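(* Assume: (A1) for each $j\in N$: (i) there exists $x^{s,*}_j$ with $f_j(x^{s,*}_j,0)=0$; (ii) for every constant $\bar\omega_j\in\mathbb{R}$, every compact invariant set of $\dot x^s_j=f_j(x^s_j,-\bar\omega_j)$ consists only of equilibrium points; (A2) there exists at least one bus $j\in N$ such that whenever $f_j(\bar x^s_j,-\bar\omega_j)=0$ for constants $\bar x^s_j,\bar\omega_j$, then $\bar\omega_j=0$. Let $z^*=(x^*,\sigma^* )$, $x^*=(\eta^*,\omega^*,x^{s,*})$, be an equilibrium of the hybrid system $\mathcal H=(C,f,D,g)$ (then $\omega^*=0$, $\sigma^*=0$) such that (A3) for each $j\in N$, the system $\dot x^s_j=f_j(x^s_j,u)$, $s_j=g_j(x^s_j,u)$ (input $u=-\omega_j$) is locally input strictly passive around the input $u=0$ and the point $x^{s,*}_j$, with a storage function $V^S_j$ having a strict local minimum at $x^{s,*}_j$; (A4) $|\eta^*_{ij}|<\pi/2$ for all $(i,j)\in E$. Then there exists an open neighborhood $S$ of $x^*$ such that every solution $z=(x,\sigma)$ of $\mathcal H$ with $x(0,0)\in S$ and $\sigma_j(0,0)\in\mathcal I_j(\omega_j(0,0))$ for all $j$ converges, as $t+\ell\to\infty$ along its hybrid time domain, to the set of equilibria of $\mathcal H$; in particular $\omega\to0_{|N|}$ and $\sigma\to0_{|N|}$.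
   Context: Network model. $(N,E)$ is a connected directed graph with $N=\{1,\dots,|N|\}$, $E\subseteq N\times N$, with arbitrary orientation: if $(i,j)\in E$ then $(j,i)\notin E$. For $j\in N$, ''$i:i\to j$'' ranges over $i$ with $(i,j)\in E$ and ''$k:j\to k$'' over $k$ with $(j,k)\in E$. Constants: $M_j>0$, $p^L_j\in\mathbb{R}$ ($j\in N$), $B_{ij}>0$ ($(i,j)\in E$). Continuous state $x=(\eta,\omega,x^s)\in\mathbb{R}^n$ with $\eta_{ij}\in\mathbb{R}$ ($(i,j)\in E$), $\omega_j\in\mathbb{R}$, $x^s_j\in\mathbb{R}^{n_j}$ ($j\in N$), $n=|E|+|N|+\sum_jn_j$; $p_{ij}=B_{ij}\sin\eta_{ij}$, $s_j=g_j(x^s_j,-\omega_j)$, where $f_j:\mathbb{R}^{n_j}\times\mathbb{R}\to\mathbb{R}^{n_j}$, $g_j:\mathbb{R}^{n_j}\times\mathbb{R}\to\mathbb{R}$ are globally Lipschitz. Hysteretic loads as a hybrid system. For each $j$ constants $\overline d_j\ge0$ and thresholds $\omega^1_j>\omega^0_j>0$ are given. ${\rm sgn}(a)=1$ if $a\ge0$ and $-1$ otherwise. The discrete state is $\sigma\in P^{|N|}$, $P=\{-1,0,1\}$, and $z=(x,\sigma)$. Let $\mathcal I_j(\omega_j)=\{{\rm sgn}(\omega_j)\}$ if $|\omega_j|>\omega^1_j$, $\{0\}$ if $|\omega_j|<\omega^0_j$, $\{0,{\rm sgn}(\omega_j)\}$ if $\omega^0_j\le|\omega_j|\le\omega^1_j$;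 $\Lambda=C=\{z\in\mathbb{R}^n\times P^{|N|}:\sigma_j\in\mathcal I_j(\omega_j)\ \forall j\}$. Flow map $f$ on $C$: $\dot\eta_{ij}=\omega_i-\omega_j$; $M_j\dot\omega_j=-p^L_j+s_j-\overline d_j\sigma_j-\sum_{k:j\to k}p_{jk}+\sum_{i:i\to j}p_{ij}$; $\dot x^s_j=f_j(x^s_j,-\omega_j)$; $\dot\sigma_j=0$. Jump set $D$: the set of $z\in\Lambda$ such that for some $j$, either ($|\omega_j|=\omega^1_j$ and $\sigma_j=0$) or ($|\omega_j|=\omega^0_j$ and $\sigma_j={\rm sgn}(\omega_j)$). Jump map $g$ on $D$: $x^+=x$; $\sigma_j^+={\rm sgn}(\omega_j)$ if $|\omega_j|=\omega^1_j$ and $\sigma_j=0$, $\sigma_j^+=0$ if $|\omega_j|=\omega^0_j$ and $\sigma_j={\rm sgn}(\omega_j)$, $\sigma_j^+=\sigma_j$ otherwise. A point $z^*$ is an equilibrium of $\mathcal H$ if $f(z^* )=0$ whenever $z^*\in C$ and $g(z^* )=z^*$ whenever $z^*\in D$. Hybrid solutions. A hybrid time domain is a subset $K\subseteq\mathbb{R}_{\ge0}\times\mathbb{N}_0$ that is a union of a finite or infinite sequence of sets $[t_\ell,t_{\ell+1}]\times\{\ell\}$ ($0=t_0\le t_1\le\dots$), the last one (if any) possibly of the form $[t_\ell,t_{\ell+1})\times\{\ell\}$ or $[t_\ell,\infty)\times\{\ell\}$. A solution of $\mathcal H$ is a map $z:K\to\mathbb{R}^n\times P^{|N|}$ on a hybrid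 time domain with $z(0,0)\in C\cup D$, such that for each $\ell$, $t\mapsto z(t,\ell)$ is locally absolutely continuous on $T_\ell=\{t:(t,\ell)\in K\}$, and if $T_\ell$ has nonempty interior then $z(t,\ell)\in C$ for all $t$ in the interior and $\dot z(t,\ell)=f(z(t,\ell))$ for almost all $t\in T_\ell$; and whenever $(t,\ell),(t,\ell+1)\in K$, $z(t,\ell)\in D$ and $z(t,\ell+1)=g(z(t,\ell))$. Solutions are taken maximal (not extendable to a solution on a strictly larger hybrid time domain). Passivity. The system $\dot x^s_j=f_j(x^s_j,u)$, $s_j=g_j(x^s_j,u)$ is locally input strictly passive around the constant input $\bar u$ and point $\bar x^s_j$ if there exist open neighborhoods $\Omega_j$ of $\bar u$ and $X^s_j$ of $\bar x^s_j$, a continuously differentiable positive semidefinite function $V^S_j:\mathbb{R}^{n_j}\to\mathbb{R}$ (storage function) and a positive definite function $\phi_j:\mathbb{R}\to\mathbb{R}$ such that for all $u\in\Omega_j$ and $x^s_j\in X^s_j$: $\frac{\partial V^S_j}{\partial x^s_j}(x^s_j)\,f_j(x^s_j,u)\le (u-\bar u)(g_j(x^s_j,u)-\bar s_j)-\phi_j(u-\bar u)$, where $\bar s_j=g_j(\bar x^s_j,\bar u)$. *)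

From Stdlib Require Vectors.Fin.
From Stdlib Require Import Reals Lra ZArith Relations.
From Stdlib Require Import Relations.Relation_Operators.
Open Scope R_scope.

Fixpoint fsum (n : nat) : (Fin.t n -> R) -> R :=
  match n return (Fin.t n -> R) -> R with
  | O => fun _ => 0
  | S m => fun f => f Fin.F1 + fsum m (fun i => f (Fin.FS i))
  end.

Fixpoint rsum (n : nat) (f : nat -> R) : R :=
  match n with O => 0 | S m => rsum m f + f m end.

Definition Vec (n : nat) := Fin.t n -> R.
Definition vnorm {n} (v : Vec n) : R := fsum n (fun i => Rabs (v i)).
Definition vsub {n} (v w : Vec n) : Vec n := fun i => v i - w i.
Definition vdot {n} (v w : Vec n) : R := fsum n (fun i => v i * w i).

Definition vopen {n} (X : Vec n -> Prop) : Prop :=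
  forall x, X x -> exists d, 0 < d /\ forall y, vnorm (vsub y x) < d -> X y.
Definition ropen (O : R -> Prop) : Prop :=
  forall x, O x -> exists d, 0 < d /\ forall y, Rabs (y - x) < d -> O y.

(* compact subsets of R^n: closed and bounded (Heine-Borel) *)
Definition vcompact {n} (M : Vec n -> Prop) : Prop :=
  (exists r, forall x, M x -> vnorm x <= r) /\
  (forall x, (forall eps, 0 < eps -> exists y, M y /\ vnorm (vsub x y) < eps) -> M x).

Definition C1_with_grad {n} (V : Vec n -> R) (G : Vec n -> Vec n) : Prop :=
  (forall x eps, 0 < eps -> exists d, 0 < d /\ forall y, vnorm (vsub y x) < d ->
      Rabs (V y - V x - vdot (G x) (vsub y x)) <= eps * vnorm (vsub y x)) /\
  (forall x eps, 0 < eps -> exists d, 0 < d /\ forall y, vnorm (vsub y x) < d ->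
      vnorm (vsub (G y) (G x)) < eps).

Definition ode_solution {n} (F : Vec n -> Vec n) (phi : R -> Vec n) : Prop :=
  forall t i, derivable_pt_lim (fun s => phi s i) t (F (phi t) i).

Definition invariant_set {n} (F : Vec n -> Vec n) (M : Vec n -> Prop) : Prop :=
  forall phi, ode_solution F phi -> M (phi 0) -> forall t, M (phi t).

Definition pos_def (phi : R -> R) : Prop :=
  phi 0 = 0 /\ forall u, u <> 0 -> 0 < phi u.

Definition loc_ISP {n} (f : Vec n -> R -> Vec n) (g : Vec n -> R -> R)
    (ub : R) (xb : Vec n) (V : Vec n -> R) : Prop :=
  exists (Om : R -> Prop) (X : Vec n -> Prop) (G : Vec n -> Vec n) (phi : R -> R),
    ropen Om /\ Om ub /\ vopen X /\ X xb /\
    C1_with_grad V G /\ (forall x, 0 <= V x) /\ pos_def phi /\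
    forall u x, Om u -> X x ->
      vdot (G x) (f x u) <= (u - ub) * (g x u - g xb ub) - phi (u - ub).

Definition strict_local_min {n} (V : Vec n -> R) (xb : Vec n) : Prop :=
  exists d, 0 < d /\ forall y, 0 < vnorm (vsub y xb) < d -> V xb < V y.

(* Buses are Fin.t nN (paper: {1,..,|N|}); edges are Fin.t nE, edge e
   being the ordered pair (src e, dst e). *)
Record Net := mkNet {
  nN : nat;
  nE : nat;
  src : Fin.t nE -> Fin.t nN;
  dst : Fin.t nE -> Fin.t nN;
  nd : Fin.t nN -> nat;
  fs : forall j, Vec (nd j) -> R -> Vec (nd j);
  gs : forall j, Vec (nd j) -> R -> R;
  Mc : Fin.t nN -> R;
  pL : Fin.t nN -> R;
  Bc : Fin.t nE -> R;
  dbar : Fin.t nN -> R;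
  w0 : Fin.t nN -> R;
  w1 : Fin.t nN -> R
}.

Definition adjacent (Nw : Net) (i j : Fin.t (nN Nw)) : Prop :=
  exists e, (src Nw e = i /\ dst Nw e = j) \/ (src Nw e = j /\ dst Nw e = i).

Definition globally_lipschitz {n} (f : Vec n -> R -> Vec n) (g : Vec n -> R -> R) : Prop :=
  exists L, forall x y u v,
    vnorm (vsub (f x u) (f y v)) <= L * (vnorm (vsub x y) + Rabs (u - v)) /\
    Rabs (g x u - g y v) <= L * (vnorm (vsub x y) + Rabs (u - v)).

Definition net_assumptions (Nw : Net) : Prop :=
  (forall e e', src Nw e = src Nw e' -> dst Nw e = dst Nw e' -> e = e') /\
  (* arbitrary orientation: (i,j) in E -> (j,i) not in E (so no self loops) *)
  (forall e e', ~ (src Nw e = dst Nw e' /\ dst Nw e = src Nw e')) /\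
  (forall i j, clos_refl_trans _ (adjacent Nw) i j) /\
  (forall j, 0 < Mc Nw j) /\
  (forall e, 0 < Bc Nw e) /\
  (forall j, 0 <= dbar Nw j) /\
  (forall j, 0 < w0 Nw j < w1 Nw j) /\
  (forall j, globally_lipschitz (fs Nw j) (gs Nw j)).

Record state (Nw : Net) := mkState {
  eta : Fin.t (nE Nw) -> R;
  om  : Fin.t (nN Nw) -> R;
  xs  : forall j, Vec (nd Nw j)
}.
Arguments mkState {Nw}.
Arguments eta {Nw}.
Arguments om {Nw}.
Arguments xs {Nw}.

(* hybrid state z = (x, sigma), sigma_j in {-1,0,1} encoded in Z *)
Record hstate (Nw : Net) := mkH { hx : state Nw; sg : Fin.t (nN Nw) -> Z }.
Arguments mkH {Nw}.
Arguments hx {Nw}.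
Arguments sg {Nw}.

Definition sgn (a : R) : Z := if Rle_dec 0 a then 1%Z else (-1)%Z.

Definition inI (w0j w1j w : R) (s : Z) : Prop :=
  (w1j < Rabs w /\ s = sgn w) \/
  (Rabs w < w0j /\ s = 0%Z) \/
  (w0j <= Rabs w <= w1j /\ (s = 0%Z \/ s = sgn w)).

Definition inC {Nw} (z : hstate Nw) : Prop :=
  forall j, inI (w0 Nw j) (w1 Nw j) (om (hx z) j) (sg z j).

Definition inD {Nw} (z : hstate Nw) : Prop :=
  inC z /\ exists j,
    (Rabs (om (hx z) j) = w1 Nw j /\ sg z j = 0%Z) \/
    (Rabs (om (hx z) j) = w0 Nw j /\ sg z j = sgn (om (hx z) j)).

Definition pflow {Nw} (x : state Nw) (e : Fin.t (nE Nw)) : R := Bc Nw e * sin (eta x e).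

Definition flow_eta {Nw} (z : hstate Nw) (e : Fin.t (nE Nw)) : R :=
  om (hx z) (src Nw e) - om (hx z) (dst Nw e).

Definition flow_om {Nw} (z : hstate Nw) (j : Fin.t (nN Nw)) : R :=
  let x := hx z in
  ( - pL Nw j + gs Nw j (xs x j) (- om x j) - dbar Nw j * IZR (sg z j)
    - fsum (nE Nw) (fun e => if Fin.eq_dec (src Nw e) j then pflow x e else 0)
    + fsum (nE Nw) (fun e => if Fin.eq_dec (dst Nw e) j then pflow x e else 0) )
  / Mc Nw j.

Definition flow_xs {Nw} (z : hstate Nw) (j : Fin.t (nN Nw)) : Vec (nd Nw j) :=
  fs Nw j (xs (hx z) j) (- om (hx z) j).

Definition jump_sg {Nw} (z : hstate Nw) (j : Fin.t (nN Nw)) : Z :=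
  let w := om (hx z) j in
  if Req_EM_T (Rabs w) (w1 Nw j) then
    (if Z.eq_dec (sg z j) 0 then sgn w
     else if Req_EM_T (Rabs w) (w0 Nw j) then
            (if Z.eq_dec (sg z j) (sgn w) then 0%Z else sg z j)
          else sg z j)
  else if Req_EM_T (Rabs w) (w0 Nw j) then
    (if Z.eq_dec (sg z j) (sgn w) then 0%Z else sg z j)
  else sg z j.

Definition jump {Nw} (z : hstate Nw) : hstate Nw := mkH (hx z) (jump_sg z).

Definition equilibrium {Nw} (z : hstate Nw) : Prop :=
  (inC z \/ inD z) /\
  (inC z -> (forall e, flow_eta z e = 0) /\ (forall j, flow_om z j = 0) /\
            (forall j k, flow_xs z j k = 0)) /\
  (inD z -> jump z = z).

Inductive last_kind := LClosed | LOpen | LInf.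

Definition last_piece (k : last_kind) (a b t : R) : Prop :=
  match k with
  | LClosed => a <= t <= b
  | LOpen => a <= t < b
  | LInf => a <= t
  end.

Definition hybrid_time_domain (K : R -> nat -> Prop) : Prop :=
  exists tt : nat -> R, tt O = 0 /\ (forall l, tt l <= tt (S l)) /\
   ( (forall t l, K t l <-> tt l <= t <= tt (S l))
   \/ exists (J : nat) (k : last_kind), forall t l,
        K t l <-> ((l < J)%nat /\ tt l <= t <= tt (S l)) \/
                  (l = J /\ last_piece k (tt J) (tt (S J)) t)).

Definition abs_cont_on (phi : R -> R) (a b : R) : Prop :=
  forall eps, 0 < eps -> exists d, 0 < d /\
    forall (n : nat) (u v : nat -> R),
      (forall i, (i < n)%nat -> a <= u i <= v i /\ v i <= b) ->
      (forall i, (S i < n)%nat -> v i <= u (S i)) ->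
      rsum n (fun i => v i - u i) < d ->
      rsum n (fun i => Rabs (phi (v i) - phi (u i))) < eps.

Definition null_set (A : R -> Prop) : Prop :=
  forall eps, 0 < eps -> exists a b : nat -> R,
    (forall i, a i <= b i) /\
    (forall t, A t -> exists i, a i < t < b i) /\
    (forall n, rsum n (fun i => b i - a i) <= eps).

Definition flow_deriv_at {Nw} (z : R -> nat -> hstate Nw) (l : nat) (t : R) : Prop :=
  (forall e, derivable_pt_lim (fun s => eta (hx (z s l)) e) t (flow_eta (z t l) e)) /\
  (forall j, derivable_pt_lim (fun s => om (hx (z s l)) j) t (flow_om (z t l) j)) /\
  (forall j k, derivable_pt_lim (fun s => xs (hx (z s l)) j k) t (flow_xs (z t l) j k)).

Definition flow_ok {Nw} (K : R -> nat -> Prop) (z : R -> nat -> hstate Nw) (l : nat) : Prop :=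
  (forall a b, K a l -> K b l -> a <= b ->
     (forall e, abs_cont_on (fun s => eta (hx (z s l)) e) a b) /\
     (forall j, abs_cont_on (fun s => om (hx (z s l)) j) a b) /\
     (forall j k, abs_cont_on (fun s => xs (hx (z s l)) j k) a b)) /\
  (forall t t', K t l -> K t' l -> sg (z t l) = sg (z t' l)) /\
  (forall t, (exists d, 0 < d /\ forall s, Rabs (s - t) < d -> K s l) -> inC (z t l)) /\
  null_set (fun t => K t l /\ ~ flow_deriv_at z l t).

Definition is_solution {Nw} (K : R -> nat -> Prop) (z : R -> nat -> hstate Nw) : Prop :=
  hybrid_time_domain K /\ K 0 O /\
  (inC (z 0 O) \/ inD (z 0 O)) /\
  (forall l, flow_ok K z l) /\
  (forall t l, K t l -> K t (S l) -> inD (z t l) /\ z t (S l) = jump (z t l)).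

Definition maximal_solution {Nw} (K : R -> nat -> Prop) (z : R -> nat -> hstate Nw) : Prop :=
  is_solution K z /\
  forall K' z', is_solution K' z' ->
    (forall t l, K t l -> K' t l /\ z' t l = z t l) ->
    (forall t l, K' t l -> K t l).

Definition xclose {Nw} (d : R) (x y : state Nw) : Prop :=
  (forall e, Rabs (eta x e - eta y e) < d) /\
  (forall j, Rabs (om x j - om y j) < d) /\
  (forall j k, Rabs (xs x j k - xs y j k) < d).

Definition zclose {Nw} (d : R) (z1 z2 : hstate Nw) : Prop :=
  xclose d (hx z1) (hx z2) /\ forall j, Rabs (IZR (sg z1 j) - IZR (sg z2 j)) < d.

Definition open_states {Nw} (S : state Nw -> Prop) : Prop :=
  forall x, S x -> exists d, 0 < d /\ forall y, xclose d x y -> S y.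

Definition converges_to_equilibria {Nw} (K : R -> nat -> Prop) (z : R -> nat -> hstate Nw) : Prop :=
  forall eps, 0 < eps -> exists T, forall t l, K t l -> T <= t + INR l ->
    exists ze, equilibrium ze /\ zclose eps (z t l) ze.

Definition omega_sigma_to_zero {Nw} (K : R -> nat -> Prop) (z : R -> nat -> hstate Nw) : Prop :=
  (forall eps, 0 < eps -> exists T, forall t l, K t l -> T <= t + INR l ->
     forall j, Rabs (om (hx (z t l)) j) < eps) /\
  (forall eps, 0 < eps -> exists T, forall t l, K t l -> T <= t + INR l ->
     forall j, Rabs (IZR (sg (z t l) j)) < eps).

From Stdlib Require Import Reals Lra Lia ZArith List ClassicalEpsilon Classical FunctionalExtensionality.
From Stdlib Require Import Relations.Relation_Operators.
Open Scope R_scope.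

(* Near x* the energy
     W = sum_j M_j w_j^2 / 2 + sum_(i,j) B_ij (cos eta*_ij - cos eta_ij - sin eta*_ij (eta_ij - eta*_ij))
         + sum_j (V_j(x^s_j) - V_j(x^s*_j))
   is nonnegative and vanishes at x*; by the power balance at x* and input strict passivity it
   decreases along the flow, at a rate bounded below by sum_j phi_j(w_j), as long as all loads are
   off. Take a box of radius r < w^0_j around x* on which all of this holds and a sublevel set of W
   below its minimum on the boundary of the box. A solution starting there cannot reach the
   boundary, and since |w_j| < w^0_j forces sigma_j = 0 it never jumps: it is a solution of
   an ODE. The dissipation forces w -> 0. A LaSalle argument then shows that every limit
   point is an equilibrium: its frequencies vanish, so does its frequency derivative (otherwise
   w would keep moving), and its x^s_j lies in the omega-limit set of x^s_j, which is a compact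
   invariant set of the frozen dynamics x' = f_j(x, 0) (by Gronwall tracking), hence consists of
   equilibria by (A1)(ii). Solutions whose domain is bounded satisfy the conclusion vacuously. *)

(** * Finite sums and the l1 norm *)

Lemma fsum_ext n (f g : Fin.t n -> R) : (forall i, f i = g i) -> fsum n f = fsum n g.
Proof.
  revert f g; induction n as [|n IH]; simpl; intros f g H; auto.
  rewrite H, (IH _ (fun i => g (Fin.FS i))); auto.
Qed.

Lemma fsum_le n (f g : Fin.t n -> R) : (forall i, f i <= g i) -> fsum n f <= fsum n g.
Proof.
  revert f g; induction n as [|n IH]; simpl; intros f g H; [lra|].
  pose proof (IH (fun i => f (Fin.FS i)) (fun i => g (Fin.FS i)) (fun i => H _)).
  specialize (H Fin.F1); lra.
Qed.

Lemma fsum_plus n (f g : Fin.t n -> R) : fsum n (fun i => f i + g i) = fsum n f + fsum n g.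
Proof. revert f g; induction n as [|n IH]; simpl; intros f g; [lra|]. rewrite IH; lra. Qed.

Lemma fsum_scal n c (f : Fin.t n -> R) : fsum n (fun i => c * f i) = c * fsum n f.
Proof. revert f; induction n as [|n IH]; simpl; intros f; [lra|]. rewrite IH; lra. Qed.

Lemma fsum_opp n (f : Fin.t n -> R) : fsum n (fun i => - f i) = - fsum n f.
Proof. revert f; induction n as [|n IH]; simpl; intros f; [lra|]. rewrite IH; lra. Qed.

Lemma fsum_minus n (f g : Fin.t n -> R) : fsum n (fun i => f i - g i) = fsum n f - fsum n g.
Proof. revert f g; induction n as [|n IH]; simpl; intros f g; [lra|]. rewrite IH; lra. Qed.

Lemma fsum_const n c : fsum n (fun _ => c) = INR n * c.
Proof. induction n as [|n IH]; simpl fsum; [simpl; lra|]. rewrite IH, S_INR; lra. Qed.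

Lemma fsum_zero n (f : Fin.t n -> R) : (forall i, f i = 0) -> fsum n f = 0.
Proof. intro H. rewrite (fsum_ext n f (fun _ => 0)), fsum_const; auto; lra. Qed.

Lemma fsum_nonneg n (f : Fin.t n -> R) : (forall i, 0 <= f i) -> 0 <= fsum n f.
Proof. intro H. rewrite <- (fsum_zero n (fun _ => 0)) by auto. apply fsum_le; auto. Qed.

Lemma fsum_le_const n (f : Fin.t n -> R) c : (forall i, f i <= c) -> fsum n f <= INR n * c.
Proof. intro H. rewrite <- fsum_const. apply fsum_le; auto. Qed.

Lemma Rabs_fsum n (f : Fin.t n -> R) : Rabs (fsum n f) <= fsum n (fun i => Rabs (f i)).
Proof.
  revert f; induction n as [|n IH]; simpl; intros f; [rewrite Rabs_R0; lra|].
  eapply Rle_trans; [apply Rabs_triang|]. specialize (IH (fun i => f (Fin.FS i))); lra.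
Qed.

Lemma fsum_ge_term n (f : Fin.t n -> R) i : (forall j, 0 <= f j) -> f i <= fsum n f.
Proof.
  revert f i; induction n as [|n IH]; intros f i H; [inversion i|simpl].
  pose proof (fsum_nonneg n (fun i => f (Fin.FS i)) (fun i => H _)).
  revert f H H0; pattern i; apply Fin.caseS'.
  - intros f H _. pose proof (fsum_nonneg n (fun i => f (Fin.FS i)) (fun i => H _)). lra.
  - intros p f H _. pose proof (IH (fun i => f (Fin.FS i)) p (fun i => H _)). specialize (H Fin.F1). lra.
Qed.

Lemma fsum_swap n m (f : Fin.t n -> Fin.t m -> R) :
  fsum n (fun i => fsum m (fun j => f i j)) = fsum m (fun j => fsum n (fun i => f i j)).
Proof.
  revert m f; induction n as [|n IH]; intros m f; simpl.
  - rewrite fsum_zero; auto.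
  - rewrite IH, <- fsum_plus. reflexivity.
Qed.

Lemma fsum_delta n (k : Fin.t n) (g : Fin.t n -> R) :
  fsum n (fun j => if Fin.eq_dec k j then g j else 0) = g k.
Proof.
  revert k g; induction n as [|n IH]; intros k g; [inversion k|simpl].
  revert g; pattern k; apply Fin.caseS'.
  - intros g. destruct (Fin.eq_dec Fin.F1 Fin.F1) as [_|C]; [|congruence].
    rewrite fsum_zero; [lra|]. intro i.
    destruct (Fin.eq_dec Fin.F1 (Fin.FS i)) as [C|]; auto. inversion C.
  - intros p g. destruct (Fin.eq_dec (Fin.FS p) Fin.F1) as [C|_]; [inversion C|].
    rewrite <- (IH p (fun i => g (Fin.FS i))), Rplus_0_l. apply fsum_ext. intro i.
    destruct (Fin.eq_dec (Fin.FS p) (Fin.FS i)) as [E|E]; destruct (Fin.eq_dec p i) as [E'|E']; auto.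
    + apply Fin.FS_inj in E. congruence.
    + subst. congruence.
Qed.

Lemma fsum_incidence nn ne (f : Fin.t ne -> Fin.t nn) (q : Fin.t ne -> R) (a : Fin.t nn -> R) :
  fsum nn (fun j => a j * fsum ne (fun e => if Fin.eq_dec (f e) j then q e else 0)) =
  fsum ne (fun e => q e * a (f e)).
Proof.
  rewrite (fsum_ext nn _ (fun j => fsum ne (fun e => if Fin.eq_dec (f e) j then a j * q e else 0))).
  - rewrite fsum_swap. apply fsum_ext. intro e. rewrite (fsum_delta nn (f e) (fun j => a j * q e)). ring.
  - intro j. rewrite <- fsum_scal. apply fsum_ext. intro e. destruct (Fin.eq_dec (f e) j); ring.
Qed.

Lemma Un_cv_fsum n (f : nat -> Fin.t n -> R) (L : Fin.t n -> R) :
  (forall i, Un_cv (fun m => f m i) (L i)) -> Un_cv (fun m => fsum n (f m)) (fsum n L).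
Proof.
  revert f L; induction n as [|n IH]; intros f L H; simpl.
  - intros e He. exists O. intros. unfold Rdist. rewrite Rminus_0_r, Rabs_R0. lra.
  - apply CV_plus; [apply H|]. apply (IH (fun m i => f m (Fin.FS i))). intro; apply H.
Qed.

Lemma derivable_pt_lim_fsum n (f : Fin.t n -> R -> R) (d : Fin.t n -> R) c :
  (forall i, derivable_pt_lim (f i) c (d i)) ->
  derivable_pt_lim (fun t => fsum n (fun i => f i t)) c (fsum n d).
Proof.
  revert f d; induction n as [|n IH]; intros f d H; simpl; [apply derivable_pt_lim_const|].
  apply (derivable_pt_lim_plus (f Fin.F1) (fun t => fsum n (fun i => f (Fin.FS i) t))); [apply H|].
  apply (IH (fun i => f (Fin.FS i)) (fun i => d (Fin.FS i))). intro; apply H.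
Qed.

Lemma fin_common_radius n (P : Fin.t n -> R -> Prop) :
  (forall i d d', 0 < d' <= d -> P i d -> P i d') -> (forall i, exists d, 0 < d /\ P i d) ->
  exists d, 0 < d /\ forall i, P i d.
Proof.
  revert P; induction n as [|n IH]; intros P Hm H.
  - exists 1; split; [lra|]. intro i; inversion i.
  - destruct (H Fin.F1) as [d1 [H1 H1']].
    destruct (IH (fun i => P (Fin.FS i))) as [d2 [H2 H2']]; [intros; eapply Hm; eauto|intros; apply H|].
    pose proof (Rmin_pos _ _ H1 H2). pose proof (Rmin_l d1 d2). pose proof (Rmin_r d1 d2).
    exists (Rmin d1 d2). split; auto. intro i. pattern i. apply Fin.caseS'.
    + eapply Hm; [|apply H1']. lra.
    + intro p. eapply Hm; [|apply H2']. lra.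
Qed.

Lemma fsum_near {T : Type} n (F : Fin.t n -> T -> R) (Cl : R -> T -> Prop) (x0 : T) :
  (forall d d' y, 0 < d' <= d -> Cl d' y -> Cl d y) ->
  (forall i eps, 0 < eps -> exists del, 0 < del /\ forall y, Cl del y -> Rabs (F i y - F i x0) < eps) ->
  forall eps, 0 < eps -> exists del, 0 < del /\ forall y, Cl del y ->
    Rabs (fsum n (fun i => F i y) - fsum n (fun i => F i x0)) <= eps.
Proof.
  intros Hm HF eps He. pose proof (pos_INR n) as Hn.
  destruct (fin_common_radius n (fun i del => forall y, Cl del y -> Rabs (F i y - F i x0) < eps / (INR n + 1)))
    as [d [Hd HH]].
  - intros i d d' Hd' Hp y Hy. apply Hp. eapply Hm; eauto.
  - intro i. apply HF. apply Rdiv_lt_0_compat; lra.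
  - exists d. split; auto. intros y Hy. rewrite <- fsum_minus.
    eapply Rle_trans; [apply Rabs_fsum|].
    apply Rle_trans with (INR n * (eps / (INR n + 1))).
    + apply fsum_le_const. intro i. left; apply HH; auto.
    + apply Rmult_le_reg_r with (INR n + 1); [lra|].
      replace (INR n * (eps / (INR n + 1)) * (INR n + 1)) with (INR n * eps) by (field; lra). nra.
Qed.

Lemma vnorm_nonneg n (v : Vec n) : 0 <= vnorm v.
Proof. apply fsum_nonneg. intro; apply Rabs_pos. Qed.

Lemma Rabs_coord_le_vnorm n (v : Vec n) k : Rabs (v k) <= vnorm v.
Proof. apply (fsum_ge_term n (fun i => Rabs (v i))). intro; apply Rabs_pos. Qed.

Lemma vnorm_le_coord_bound n (v : Vec n) e : (forall i, Rabs (v i) <= e) -> vnorm v <= INR n * e.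
Proof. intro; apply fsum_le_const; auto. Qed.

Lemma vnorm_vsub_triang n (x y z : Vec n) : vnorm (vsub x z) <= vnorm (vsub x y) + vnorm (vsub y z).
Proof.
  unfold vnorm, vsub. rewrite <- fsum_plus. apply fsum_le. intro i.
  replace (x i - z i) with ((x i - y i) + (y i - z i)) by ring. apply Rabs_triang.
Qed.

Lemma vnorm_le_vsub n (p q : Vec n) : vnorm p <= vnorm (vsub p q) + vnorm q.
Proof.
  unfold vnorm, vsub. rewrite <- fsum_plus. apply fsum_le. intro i.
  replace (p i) with ((p i - q i) + q i) at 1 by ring. apply Rabs_triang.
Qed.

Lemma vnorm_vsub_sym n (x y : Vec n) : vnorm (vsub x y) = vnorm (vsub y x).
Proof. apply fsum_ext. intro; apply Rabs_minus_sym. Qed.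

Lemma vnorm_vsub_opp n (a b : Vec n) : vnorm (vsub (fun k => - a k) (fun k => - b k)) = vnorm (vsub a b).
Proof. apply fsum_ext. intro i. unfold vsub. rewrite <- Rabs_Ropp. f_equal; ring. Qed.

Lemma vnorm_vsub_eq0 n (y x : Vec n) : vnorm (vsub y x) = 0 -> y = x.
Proof.
  intro H. apply functional_extensionality. intro k.
  pose proof (Rabs_coord_le_vnorm n (vsub y x) k). pose proof (Rabs_pos (y k - x k)).
  destruct (Req_dec (y k - x k) 0) as [E|E]; [lra|].
  apply Rabs_no_R0 in E. unfold vsub in *. lra.
Qed.

Lemma Rabs_vdot_le n (g h : Vec n) : Rabs (vdot g h) <= vnorm g * vnorm h.
Proof.
  unfold vdot. eapply Rle_trans; [apply Rabs_fsum|].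
  apply Rle_trans with (fsum n (fun i => vnorm h * Rabs (g i))).
  - apply fsum_le. intro i. rewrite Rabs_mult, Rmult_comm.
    apply Rmult_le_compat_r; [apply Rabs_pos|apply Rabs_coord_le_vnorm].
  - rewrite fsum_scal. unfold vnorm at 2. lra.
Qed.

Lemma vdot_minus n (g a b : Vec n) : vdot g a - vdot g b = vdot g (vsub a b).
Proof. unfold vdot. rewrite <- fsum_minus. apply fsum_ext. intro; unfold vsub; ring. Qed.

Lemma vdot_minus_split n (a b c d : Vec n) : vdot a b - vdot c d = vdot (vsub a c) b + vdot c (vsub b d).
Proof. unfold vdot, vsub. rewrite <- fsum_minus, <- fsum_plus. apply fsum_ext; intro; ring. Qed.

(** * Derivatives and the mean value inequality *)

Lemma Rabs_le_inv x B : Rabs x <= B -> - B <= x <= B.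
Proof. intro H. pose proof (Rle_abs x). pose proof (Rle_abs (-x)). rewrite Rabs_Ropp in *. lra. Qed.

Lemma derivable_pt_lim_eq_ext f g t d d' :
  (forall s, f s = g s) -> d = d' -> derivable_pt_lim f t d -> derivable_pt_lim g t d'.
Proof. intros H1 H2 H. replace g with f by (apply functional_extensionality; auto). subst; auto. Qed.

Lemma derivable_pt_lim_cmul C f t d :
  derivable_pt_lim f t d -> derivable_pt_lim (fun s => C * f s) t (C * d).
Proof.
  intro H. eapply derivable_pt_lim_eq_ext;
    [| |apply (derivable_pt_lim_mult (fct_cte C) f t 0 d (derivable_pt_lim_const C t) H)].
  - reflexivity.
  - unfold fct_cte; ring.
Qed.

Lemma derivable_pt_lim_near h c d : derivable_pt_lim h c d ->
  forall eps, 0 < eps -> exists del, 0 < del /\ forall s, Rabs (s - c) < del -> Rabs (h s - h c) < eps.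
Proof.
  intros Hd eps He. destruct (derivable_continuous_pt h c (exist _ d Hd) eps He) as [del [Hdel H]].
  exists del. split; auto. intros s Hs.
  destruct (Req_dec s c) as [->|E]; [rewrite Rminus_diag, Rabs_R0; auto|].
  apply (H s). split; [split; [constructor|auto]|exact Hs].
Qed.

Lemma derivable_pt_lim_right_le h c d eps : derivable_pt_lim h c d -> 0 < eps ->
  exists del, 0 < del /\ forall s, c < s < c + del -> h s - h c <= (d + eps) * (s - c).
Proof.
  intros Hd He. destruct (Hd eps He) as [del Hdel]. exists del. split; [apply cond_pos|].
  intros s Hs. specialize (Hdel (s - c)). replace (c + (s - c)) with s in Hdel by ring.
  assert (Hq : Rabs ((h s - h c) / (s - c) - d) < eps) by (apply Hdel; [lra|rewrite Rabs_right; lra]).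
  apply Rabs_def2 in Hq.
  replace (h s - h c) with ((h s - h c) / (s - c) * (s - c)) by (field; lra).
  apply Rmult_le_compat_r; lra.
Qed.

Lemma derivable_pt_lim_left_le h c d eps : derivable_pt_lim h c d -> 0 < eps ->
  exists del, 0 < del /\ forall s, c - del < s < c -> h c - h s <= (d + eps) * (c - s).
Proof.
  intros Hd He. destruct (Hd eps He) as [del Hdel]. exists del. split; [apply cond_pos|].
  intros s Hs. specialize (Hdel (s - c)). replace (c + (s - c)) with s in Hdel by ring.
  assert (Hq : Rabs ((h s - h c) / (s - c) - d) < eps) by (apply Hdel; [lra|rewrite Rabs_left; lra]).
  apply Rabs_def2 in Hq.
  replace (h c - h s) with ((h s - h c) / (s - c) * (c - s)) by (field; lra).
  apply Rmult_le_compat_r; lra.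
Qed.

Lemma Rabs_left_increment_le h c d eps : derivable_pt_lim h c d -> 0 < eps ->
  exists del, 0 < del /\ forall s, c - del < s < c -> Rabs (h c - h s) <= (Rabs d + eps) * (c - s).
Proof.
  intros Hd He. destruct (derivable_pt_lim_left_le h c d eps Hd He) as [e1 [He1 H1]].
  destruct (derivable_pt_lim_left_le (fun s => - h s) c (- d) eps (derivable_pt_lim_opp _ _ _ Hd) He)
    as [e2 [He2 H2]].
  exists (Rmin e1 e2). split; [apply Rmin_pos; auto|]. intros s Hs.
  pose proof (Rmin_l e1 e2). pose proof (Rmin_r e1 e2).
  specialize (H1 s ltac:(lra)). specialize (H2 s ltac:(lra)). simpl in H2.
  pose proof (Rmult_le_compat_r (c - s) _ _ ltac:(lra) (Rle_abs d)).
  pose proof (Rmult_le_compat_r (c - s) _ _ ltac:(lra) (Rle_abs (- d))). rewrite Rabs_Ropp in *.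
  apply Rabs_le. lra.
Qed.

Lemma real_induction a b (Q : R -> Prop) : a <= b -> Q a ->
  (forall c, a <= c < b -> Q c -> exists del, 0 < del /\ forall s, c < s < c + del -> s <= b -> Q s) ->
  (forall c, a < c <= b -> (forall s, a <= s < c -> Q s) -> Q c) ->
  forall s, a <= s <= b -> Q s.
Proof.
  intros Hab Qa Hext Hcl.
  set (A := fun t => a <= t <= b /\ forall s, a <= s <= t -> Q s).
  assert (HaA : A a) by (split; [lra|intros s Hs; replace s with a by lra; auto]).
  assert (Hb : bound A) by (exists b; intros t [Ht _]; lra).
  destruct (completeness A Hb (ex_intro _ a HaA)) as [c [Hub Hlub]].
  assert (Hac : a <= c) by (apply Hub; auto).
  assert (Hcb : c <= b) by (apply Hlub; intros t [Ht _]; lra).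
  assert (Hbelow : forall s, a <= s < c -> Q s).
  { intros s Hs. apply NNPP. intro Hn. assert (c <= s); [|lra].
    apply Hlub. intros t [Ht Ht']. destruct (Rle_dec t s); auto.
    exfalso. apply Hn, Ht'. lra. }
  assert (Ac : A c).
  { assert (Qc : Q c) by (destruct (Req_dec c a) as [->|]; auto; apply Hcl; auto; lra).
    split; [lra|]. intros s Hs. destruct (Req_dec s c) as [->|]; auto. apply Hbelow; lra. }
  assert (Hc : c = b).
  { destruct (Req_dec c b) as [|Hne]; auto. exfalso.
    destruct (Hext c ltac:(lra) (proj2 Ac c ltac:(lra))) as [del [Hd Hdel]].
    pose proof (Rmin_l (c + del/2) b). pose proof (Rmin_r (c + del/2) b). set (s' := Rmin (c + del/2) b) in *.
    assert (c < s') by (apply Rmin_glb_lt; lra).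
    assert (s' <= c); [|lra].
    apply Hub. split; [lra|]. intros s Hs. destruct (Rle_dec s c).
    - apply (proj2 Ac); lra.
    - apply Hdel; lra. }
  subst c. intros s Hs. apply (proj2 Ac). lra.
Qed.

Lemma mean_value_le f a b M : a <= b ->
  (forall t, a <= t <= b -> exists d, derivable_pt_lim f t d /\ d <= M) -> f b - f a <= M * (b - a).
Proof.
  intros Hab Hd.
  assert (Key : forall eps, 0 < eps -> f b - f a <= (M + eps) * (b - a)).
  { intros eps He. apply (real_induction a b (fun s => f s - f a <= (M + eps) * (s - a)) Hab); [lra| | |lra].
    - intros c Hc Hq. destruct (Hd c ltac:(lra)) as [d [Hd1 Hd2]].
      destruct (derivable_pt_lim_right_le f c d eps Hd1 He) as [del [Hdel H]].
      exists del. split; auto. intros s Hs _. specialize (H s Hs).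
      pose proof (Rmult_le_compat_r (s - c) (d + eps) (M + eps) ltac:(lra) ltac:(lra)). nra.
    - intros c Hc Hq. destruct (Hd c ltac:(lra)) as [d [Hd1 Hd2]].
      destruct (derivable_pt_lim_left_le f c d eps Hd1 He) as [del [Hdel H]].
      pose proof (Rmax_l a (c - del/2)). pose proof (Rmax_r a (c - del/2)). set (s := Rmax a (c - del/2)) in *.
      assert (s < c) by (apply Rmax_lub_lt; lra).
      specialize (H s ltac:(lra)). specialize (Hq s ltac:(lra)).
      pose proof (Rmult_le_compat_r (c - s) (d + eps) (M + eps) ltac:(lra) ltac:(lra)). nra. }
  apply Rnot_lt_le. intro Hlt. destruct (Req_dec a b) as [->|]; [lra|].
  set (eps := (f b - f a - M * (b - a)) / (2 * (b - a))).
  specialize (Key eps ltac:(apply Rdiv_lt_0_compat; lra)).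
  assert ((M + eps) * (b - a) = M * (b - a) + (f b - f a - M * (b - a)) / 2) by (unfold eps; field; lra).
  lra.
Qed.

Lemma mean_value_ge f a b m : a <= b ->
  (forall t, a <= t <= b -> exists d, derivable_pt_lim f t d /\ m <= d) -> m * (b - a) <= f b - f a.
Proof.
  intros Hab Hd. pose proof (mean_value_le (fun s => - f s) a b (- m) Hab).
  enough (- f b - - f a <= - m * (b - a)) by lra. apply H. intros t Ht.
  destruct (Hd t Ht) as [d [H1 H2]]. exists (- d). split; [apply derivable_pt_lim_opp; auto|lra].
Qed.

Lemma Rabs_sin_sub_le x y : Rabs (sin x - sin y) <= Rabs (x - y).
Proof.
  assert (Hd : forall t, exists d, derivable_pt_lim sin t d /\ -1 <= d <= 1)
    by (intro t; exists (cos t); split; [apply derivable_pt_lim_sin|apply COS_bound]).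
  assert (H : forall a b, a <= b -> Rabs (sin b - sin a) <= b - a).
  { intros a b Hab. apply Rabs_le.
    pose proof (mean_value_le sin a b 1 Hab (fun t _ => let (d, Hd') := Hd t in
                  ex_intro _ d (conj (proj1 Hd') (proj2 (proj2 Hd'))))).
    pose proof (mean_value_ge sin a b (-1) Hab (fun t _ => let (d, Hd') := Hd t in
                  ex_intro _ d (conj (proj1 Hd') (proj1 (proj2 Hd'))))).
    lra. }
  destruct (Rle_dec y x).
  - rewrite (Rabs_right (x - y)) by lra. apply H; lra.
  - rewrite Rabs_minus_sym, (Rabs_left (x - y)) by lra. specialize (H x y ltac:(lra)). lra.
Qed.

Lemma derivable_pt_lim_shift f t d s :
  derivable_pt_lim f (s + t) d -> derivable_pt_lim (fun u => f (s + u)) t d.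
Proof.
  intro H. assert (H1 : derivable_pt_lim (fun u => s + u) t (0 + 1))
    by (apply (derivable_pt_lim_plus (fun _ => s) (fun u => u)); [apply derivable_pt_lim_const|apply derivable_pt_lim_id]).
  eapply derivable_pt_lim_eq_ext; [| |apply (derivable_pt_lim_comp _ f t _ _ H1 H)]; [intro; reflexivity|ring].
Qed.

Lemma derivable_pt_lim_reflect f t d s :
  derivable_pt_lim f (s - t) d -> derivable_pt_lim (fun u => f (s - u)) t (- d).
Proof.
  intro H. assert (H1 : derivable_pt_lim (fun u => s - u) t (0 - 1))
    by (apply (derivable_pt_lim_minus (fun _ => s) (fun u => u)); [apply derivable_pt_lim_const|apply derivable_pt_lim_id]).
  eapply derivable_pt_lim_eq_ext; [| |apply (derivable_pt_lim_comp _ f t _ _ H1 H)]; [intro; reflexivity|ring].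
Qed.

(** * Absolutely continuous functions *)

Definition lsum {A} (f : A -> R) (L : list A) : R := fold_right (fun p acc => f p + acc) 0 L.

Lemma lsum_app {A} (f : A -> R) L1 L2 : lsum f (L1 ++ L2) = lsum f L1 + lsum f L2.
Proof. induction L1 as [|x L1 IH]; simpl; [lra|]. rewrite IH; lra. Qed.

Lemma lsum_filter {A} (f : A -> R) (P : A -> bool) L :
  lsum f L = lsum f (filter P L) + lsum f (filter (fun x => negb (P x)) L).
Proof. induction L as [|x L IH]; simpl; [lra|]. destruct (P x); simpl; rewrite IH; lra. Qed.

Lemma rsum_lsum_nth {A} (F : A -> R) L d : rsum (length L) (fun k => F (nth k L d)) = lsum F L.
Proof.
  assert (Hshift : forall m f, rsum (S m) f = f O + rsum m (fun k => f (S k)))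
    by (induction m as [|m IH]; intro f; simpl in *; [lra|rewrite IH; lra]).
  induction L as [|x L IH]; simpl length; [reflexivity|]. rewrite Hshift. simpl. rewrite IH. reflexivity.
Qed.

Lemma ForallOrdPairs_filter {A} (Rl : A -> A -> Prop) P L :
  ForallOrdPairs Rl L -> ForallOrdPairs Rl (filter P L).
Proof.
  induction 1 as [|a L Ha HL IH]; simpl; [constructor|]. destruct (P a); auto. constructor; auto.
  apply Forall_forall. intros x Hx. apply filter_In in Hx. rewrite Forall_forall in Ha. apply Ha. tauto.
Qed.

Lemma ForallOrdPairs_snoc {A} (Rl : A -> A -> Prop) L x :
  ForallOrdPairs Rl L -> Forall (fun p => Rl p x) L -> ForallOrdPairs Rl (L ++ x :: nil).
Proof.
  induction 1 as [|a L Ha HL IH]; intros HF; simpl; [constructor; constructor|].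
  inversion HF; subst. constructor; auto. apply Forall_app. split; auto.
Qed.

Lemma ForallOrdPairs_nth {A} (Rl : A -> A -> Prop) L d : ForallOrdPairs Rl L ->
  forall i j, (i < j < length L)%nat -> Rl (nth i L d) (nth j L d).
Proof.
  induction 1 as [|a L Ha HL IH]; intros i j Hij; simpl in *; [lia|].
  destruct i, j; try lia.
  - rewrite Forall_forall in Ha. apply Ha, nth_In. lia.
  - apply IH. lia.
Qed.

(* ((lo, hi), i): an interval [lo, hi] inside the i-th interval of a cover of a null set. *)
Definition ival := (R * R * nat)%type.
Definition ival_lo (p : ival) := fst (fst p).
Definition ival_hi (p : ival) := snd (fst p).
Definition ival_idx (p : ival) := snd p.
Definition ival_len (p : ival) := ival_hi p - ival_lo p.

Definition ordered_ivals (L : list ival) := ForallOrdPairs (fun p q => ival_hi p <= ival_lo q) L.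

Lemma lsum_len_le_span L al be : al <= be -> ordered_ivals L ->
  Forall (fun p => al <= ival_lo p <= ival_hi p /\ ival_hi p <= be) L ->
  lsum ival_len L <= be - al.
Proof.
  intros Hab Ho; revert al Hab. unfold ival_len.
  induction Ho as [|p L HF Ho IH]; intros al Hab HL; simpl; [lra|].
  inversion HL as [|? ? Hp HL']; subst.
  assert (lsum (fun p => ival_hi p - ival_lo p) L <= be - ival_hi p); [|lra].
  apply IH; [lra|]. rewrite Forall_forall in *. intros x Hx. specialize (HF x Hx). specialize (HL' x Hx). lra.
Qed.

Lemma lsum_len_le_cover (ca cb : nat -> R) (Hc : forall i, ca i <= cb i) N L :
  ordered_ivals L ->
  Forall (fun p => ival_lo p <= ival_hi p /\ ca (ival_idx p) < ival_lo p /\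
                   ival_hi p < cb (ival_idx p) /\ (ival_idx p < N)%nat) L ->
  lsum ival_len L <= rsum N (fun i => cb i - ca i).
Proof.
  revert L; induction N as [|N IH]; intros L Ho HL.
  - destruct L as [|p L]; [simpl; lra|]. inversion HL; lia.
  - rewrite (lsum_filter _ (fun p => Nat.eqb (ival_idx p) N)). simpl rsum.
    assert (lsum ival_len (filter (fun p => Nat.eqb (ival_idx p) N) L) <= cb N - ca N).
    { apply lsum_len_le_span; [apply Hc|apply ForallOrdPairs_filter; auto|].
      rewrite Forall_forall in *. intros x Hx. apply filter_In in Hx. destruct Hx as [Hx Hx'].
      apply Nat.eqb_eq in Hx'. specialize (HL x Hx). rewrite Hx' in HL. lra. }
    assert (lsum ival_len (filter (fun p => negb (Nat.eqb (ival_idx p) N)) L) <= rsum N (fun i => cb i - ca i)).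
    { apply IH; [apply ForallOrdPairs_filter; auto|].
      rewrite Forall_forall in *. intros x Hx. apply filter_In in Hx. destruct Hx as [Hx Hx'].
      apply Bool.negb_true_iff, Nat.eqb_neq in Hx'. specialize (HL x Hx). repeat split; try tauto. lia. }
    lra.
Qed.

Definition covered_ivals (ca cb : nat -> R) (a s : R) (L : list ival) : Prop :=
  ordered_ivals L /\
  Forall (fun p => a <= ival_lo p <= ival_hi p /\ ival_hi p <= s /\
                   ca (ival_idx p) < ival_lo p /\ ival_hi p < cb (ival_idx p)) L.

Lemma covered_ivals_mono ca cb a s s' L : s <= s' -> covered_ivals ca cb a s L -> covered_ivals ca cb a s' L.
Proof. intros H [H1 H2]. split; auto. rewrite Forall_forall in *. intros x Hx. specialize (H2 x Hx). lra. Qed.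

Lemma covered_ivals_snoc ca cb a s L u v i : covered_ivals ca cb a s L -> a <= u -> s <= u <= v ->
  ca i < u -> v < cb i -> covered_ivals ca cb a v (L ++ ((u, v), i) :: nil).
Proof.
  intros [H1 H2] Ha Huv Hu Hv. split.
  - apply ForallOrdPairs_snoc; auto. rewrite Forall_forall in *. intros x Hx. specialize (H2 x Hx).
    unfold ival_lo; simpl. lra.
  - apply Forall_app. split.
    + rewrite Forall_forall in *. intros x Hx. specialize (H2 x Hx). lra.
    + constructor; [|constructor]. unfold ival_lo, ival_hi, ival_idx; simpl. lra.
Qed.

Lemma covered_ivals_idx_bound (L : list ival) : exists N, Forall (fun p => (ival_idx p < N)%nat) L.
Proof.
  induction L as [|p L [N HN]]; [exists O; constructor|]. exists (S (Nat.max N (ival_idx p))).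
  constructor; [lia|]. rewrite Forall_forall in *. intros x Hx. specialize (HN x Hx). lia.
Qed.

Definition ival_var (h : R -> R) (p : ival) := Rabs (h (ival_hi p) - h (ival_lo p)).

(* Where h has derivative <= 0 it grows at most like eps * t; the exceptional points are absorbed
   by intervals of the cover, across which the growth is recorded in the list. *)
Lemma increment_le_covered_var (h : R -> R) a b (E : R -> Prop) ca cb eps : a <= b -> 0 < eps ->
  (forall t, E t -> exists i, ca i < t < cb i) ->
  (forall t, a <= t <= b -> ~ E t -> exists d, derivable_pt_lim h t d /\ d <= 0) ->
  exists L, covered_ivals ca cb a b L /\ h b - h a <= eps * (b - a) + lsum (ival_var h) L.
Proof.
  intros Hab Heps Hcov Hd.
  set (Q := fun s => exists L, covered_ivals ca cb a s L /\ h s - h a <= eps * (s - a) + lsum (ival_var h) L).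
  assert (Hvar1 : forall u v i, lsum (ival_var h) (((u, v), i) :: nil) = Rabs (h v - h u))
    by (intros; unfold lsum, ival_var, ival_lo, ival_hi; simpl; ring).
  apply (real_induction a b Q Hab); [| | |lra].
  - exists nil. split; [split; constructor|simpl; lra].
  - intros c Hc [L [HL HL']]. destruct (classic (E c)) as [Ec|Ec].
    + destruct (Hcov c Ec) as [i Hi]. exists (cb i - c). split; [lra|]. intros s Hs Hsb.
      exists (L ++ ((c, s), i) :: nil). split; [apply (covered_ivals_snoc ca cb a c L c s i); auto; lra|].
      rewrite lsum_app, Hvar1. pose proof (Rle_abs (h s - h c)).
      pose proof (Rmult_le_compat_l eps (c - a) (s - a) ltac:(lra) ltac:(lra)). lra.
    + destruct (Hd c ltac:(lra) Ec) as [d [Hd1 Hd2]].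
      destruct (derivable_pt_lim_right_le h c d eps Hd1 Heps) as [del [Hdel Hdel']].
      exists del. split; auto. intros s Hs Hsb. exists L.
      split; [eapply covered_ivals_mono; [|apply HL]; lra|].
      specialize (Hdel' s Hs). pose proof (Rmult_le_compat_r (s - c) (d + eps) eps ltac:(lra) ltac:(lra)). nra.
  - intros c Hc HQ. destruct (classic (E c)) as [Ec|Ec].
    + destruct (Hcov c Ec) as [i Hi].
      pose proof (Rmax_l a ((ca i + c)/2)). pose proof (Rmax_r a ((ca i + c)/2)).
      set (s := Rmax a ((ca i + c)/2)) in *. assert (s < c) by (apply Rmax_lub_lt; lra).
      destruct (HQ s ltac:(lra)) as [L [HL HL']]. exists (L ++ ((s, c), i) :: nil).
      split; [apply (covered_ivals_snoc ca cb a s L s c i); auto; lra|].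
      rewrite lsum_app, Hvar1. pose proof (Rle_abs (h c - h s)).
      pose proof (Rmult_le_compat_l eps (s - a) (c - a) ltac:(lra) ltac:(lra)). lra.
    + destruct (Hd c ltac:(lra) Ec) as [d [Hd1 Hd2]].
      destruct (derivable_pt_lim_left_le h c d eps Hd1 Heps) as [del [Hdel Hdel']].
      pose proof (Rmax_l a (c - del/2)). pose proof (Rmax_r a (c - del/2)).
      set (s := Rmax a (c - del/2)) in *. assert (s < c) by (apply Rmax_lub_lt; lra).
      destruct (HQ s ltac:(lra)) as [L [HL HL']]. exists L.
      split; [eapply covered_ivals_mono; [|apply HL]; lra|].
      specialize (Hdel' s ltac:(lra)). pose proof (Rmult_le_compat_r (c - s) (d + eps) eps ltac:(lra) ltac:(lra)). nra.
Qed.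

Lemma abs_cont_near h a b : abs_cont_on h a b -> forall eps, 0 < eps -> exists d, 0 < d /\
  forall s t, a <= s <= t -> t <= b -> t - s < d -> Rabs (h t - h s) < eps.
Proof.
  intros Hac eps He. destruct (Hac eps He) as [d [Hd Hd']]. exists d. split; auto.
  intros s t Hs Ht Hst. specialize (Hd' 1%nat (fun _ => s) (fun _ => t)). simpl in Hd'.
  rewrite !Rplus_0_l in Hd'. apply Hd'; intros; lra || lia.
Qed.

Lemma abs_cont_on_restrict h a b a' b' : abs_cont_on h a b -> a <= a' -> b' <= b -> abs_cont_on h a' b'.
Proof.
  intros Hac H1 H2 eps He. destruct (Hac eps He) as [d [Hd H]]. exists d. split; auto.
  intros n u v Hi Ho Hs. apply H; auto. intros i Hi'. specialize (Hi i Hi'). lra.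
Qed.

Lemma abs_cont_on_opp h a b : abs_cont_on h a b -> abs_cont_on (fun s => - h s) a b.
Proof.
  intros Hac eps He. destruct (Hac eps He) as [d [Hd Hd']]. exists d. split; auto. intros n u v H1 H2 H3.
  replace (rsum n (fun i => Rabs (- h (v i) - - h (u i)))) with (rsum n (fun i => Rabs (h (v i) - h (u i)))); auto.
  clear. induction n as [|n IH]; simpl; auto. rewrite IH, <- Rabs_Ropp. f_equal. f_equal. ring.
Qed.

Lemma abs_cont_on_sub_linear h a b M : abs_cont_on h a b -> abs_cont_on (fun s => h s - M * s) a b.
Proof.
  intros Hac eps He. destruct (Hac (eps/2)) as [d [Hd Hd']]; [lra|].
  pose proof (Rabs_pos M). set (d' := eps / (2 * (Rabs M + 1))).
  assert (Hd'0 : 0 < d') by (apply Rdiv_lt_0_compat; lra).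
  exists (Rmin d d'). split; [apply Rmin_pos; auto|]. intros n u v H1 H2 H3.
  pose proof (Rmin_l d d'). pose proof (Rmin_r d d').
  assert (rsum n (fun i => Rabs (h (v i) - h (u i))) < eps/2) by (apply Hd'; auto; lra).
  assert (Hs : forall m, (m <= n)%nat ->
     rsum m (fun i => Rabs (h (v i) - M * v i - (h (u i) - M * u i))) <=
     rsum m (fun i => Rabs (h (v i) - h (u i))) + Rabs M * rsum m (fun i => v i - u i)).
  { induction m as [|m IH]; intros Hm; simpl; [lra|]. specialize (IH ltac:(lia)).
    replace (h (v m) - M * v m - (h (u m) - M * u m)) with ((h (v m) - h (u m)) + (- M) * (v m - u m)) by ring.
    pose proof (Rabs_triang (h (v m) - h (u m)) (- M * (v m - u m))) as Htri.
    rewrite Rabs_mult, Rabs_Ropp in Htri.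
    specialize (H1 m ltac:(lia)). rewrite (Rabs_right (v m - u m)) in Htri by lra. lra. }
  specialize (Hs n (le_n n)).
  assert (rsum n (fun i => v i - u i) >= 0).
  { clear -H1. induction n as [|n IH]; simpl; [lra|].
    assert (rsum n (fun i => v i - u i) >= 0) by (apply IH; intros; apply H1; lia).
    specialize (H1 n ltac:(lia)). lra. }
  assert (Rabs M * rsum n (fun i => v i - u i) <= Rabs M * d') by (apply Rmult_le_compat_l; lra).
  assert (Rabs M * d' < eps / 2).
  { apply Rmult_lt_reg_r with (2 * (Rabs M + 1)); [lra|].
    unfold d'. replace (Rabs M * (eps / (2 * (Rabs M + 1))) * (2 * (Rabs M + 1))) with (Rabs M * eps) by (field; lra).
    lra. }
  lra.
Qed.

Lemma abs_cont_nonincreasing (h : R -> R) a b (E : R -> Prop) : a <= b -> abs_cont_on h a b -> null_set E ->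
  (forall t, a <= t <= b -> ~ E t -> exists d, derivable_pt_lim h t d /\ d <= 0) -> h b <= h a.
Proof.
  intros Hab Hac HE Hd.
  assert (Key : forall eps, 0 < eps -> h b - h a <= eps * (b - a) + eps).
  { intros eps Heps. destruct (Hac eps Heps) as [del [Hdel Hdel']].
    destruct (HE (del/2)) as [ca [cb [Hc1 [Hc2 Hc3]]]]; [lra|].
    destruct (increment_le_covered_var h a b E ca cb eps Hab Heps Hc2 Hd) as [L [[Ho HL] HL']].
    destruct (covered_ivals_idx_bound L) as [N HN].
    assert (Hsum : lsum ival_len L <= rsum N (fun i => cb i - ca i)).
    { apply lsum_len_le_cover; auto. rewrite Forall_forall in *. intros x Hx.
      specialize (HL x Hx). specialize (HN x Hx). repeat split; lra || auto. }
    specialize (Hc3 N). set (d0 := (0, 0, O) : ival).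
    assert (lsum (ival_var h) L < eps); [|lra].
    rewrite <- (rsum_lsum_nth _ L d0). rewrite <- (rsum_lsum_nth _ L d0) in Hsum.
    apply (Hdel' (length L) (fun k => ival_lo (nth k L d0)) (fun k => ival_hi (nth k L d0))).
    - intros i Hi. rewrite Forall_forall in HL. specialize (HL (nth i L d0) (nth_In _ _ Hi)). lra.
    - intros i Hi. apply (ForallOrdPairs_nth _ L d0 Ho). lia.
    - unfold ival_len in Hsum. lra. }
  apply Rnot_lt_le. intro Hlt. set (eps := (h b - h a) / (2 * (b - a + 1))).
  specialize (Key eps ltac:(apply Rdiv_lt_0_compat; lra)).
  assert (eps * (b - a) + eps = (h b - h a) / 2) by (unfold eps; field; lra). lra.
Qed.

Lemma abs_cont_increment_le (h : R -> R) a b (E : R -> Prop) M : a <= b -> abs_cont_on h a b -> null_set E ->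
  (forall t, a <= t <= b -> ~ E t -> exists d, derivable_pt_lim h t d /\ d <= M) -> h b - h a <= M * (b - a).
Proof.
  intros Hab Hac HE Hd.
  pose proof (abs_cont_nonincreasing (fun s => h s - M * s) a b E Hab (abs_cont_on_sub_linear h a b M Hac) HE).
  enough (h b - M * b <= h a - M * a) by lra. apply H. intros t Ht Et.
  destruct (Hd t Ht Et) as [d [Hd1 Hd2]]. exists (d - M). split; [|lra].
  apply derivable_pt_lim_minus; auto.
  replace M with (M * 1) at 2 by ring. apply derivable_pt_lim_scal, derivable_pt_lim_id.
Qed.

Lemma abs_cont_increment_ge (h : R -> R) a b (E : R -> Prop) m : a <= b -> abs_cont_on h a b -> null_set E ->
  (forall t, a <= t <= b -> ~ E t -> exists d, derivable_pt_lim h t d /\ m <= d) -> m * (b - a) <= h b - h a.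
Proof.
  intros Hab Hac HE Hd.
  pose proof (abs_cont_increment_le (fun s => - h s) a b E (-m) Hab (abs_cont_on_opp h a b Hac) HE).
  enough (- h b - - h a <= - m * (b - a)) by lra. apply H. intros t Ht Et.
  destruct (Hd t Ht Et) as [d [Hd1 Hd2]]. exists (- d). split; [apply derivable_pt_lim_opp; auto|lra].
Qed.

Lemma abs_cont_increment_near (h F : R -> R) a b (E : R -> Prop) c eps : a <= b ->
  abs_cont_on h a b -> null_set E ->
  (forall t, a <= t <= b -> ~ E t -> derivable_pt_lim h t (F t)) ->
  (forall t, a <= t <= b -> Rabs (F t - F c) < eps) ->
  Rabs (h b - h a - F c * (b - a)) <= eps * (b - a).
Proof.
  intros Hab Hac HE Hd HF. apply Rabs_le.
  assert (h b - h a <= (F c + eps) * (b - a)).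
  { apply (abs_cont_increment_le h a b E); auto. intros t Ht Et. exists (F t).
    split; [auto|]. specialize (HF t Ht). apply Rabs_def2 in HF. lra. }
  assert ((F c - eps) * (b - a) <= h b - h a).
  { apply (abs_cont_increment_ge h a b E); auto. intros t Ht Et. exists (F t).
    split; [auto|]. specialize (HF t Ht). apply Rabs_def2 in HF. lra. }
  lra.
Qed.

Lemma abs_cont_derivable (h F : R -> R) a b (E : R -> Prop) c : a < c < b -> abs_cont_on h a b -> null_set E ->
  (forall t, a <= t <= b -> ~ E t -> derivable_pt_lim h t (F t)) ->
  (forall eps, 0 < eps -> exists del, 0 < del /\
     forall s, a <= s <= b -> Rabs (s - c) < del -> Rabs (F s - F c) < eps) ->
  derivable_pt_lim h c (F c).
Proof.
  intros Hc Hac HE Hd HF eps He. destruct (HF (eps/2) ltac:(lra)) as [del [Hdel HFd]].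
  assert (Hp : 0 < Rmin del (Rmin (c - a) (b - c))) by (repeat apply Rmin_pos; lra).
  exists (mkposreal _ Hp). simpl. intros h0 Hh0 Hlt.
  pose proof (Rmin_l del (Rmin (c - a) (b - c))). pose proof (Rmin_r del (Rmin (c - a) (b - c))).
  pose proof (Rmin_l (c - a) (b - c)). pose proof (Rmin_r (c - a) (b - c)).
  assert (Hquot : Rabs ((h (c + h0) - h c) / h0 - F c) = Rabs (h (c + h0) - h c - F c * h0) / Rabs h0)
    by (unfold Rdiv; rewrite <- Rabs_inv, <- Rabs_mult; f_equal; field; auto).
  rewrite Hquot. apply Rle_lt_trans with (eps / 2); [|lra].
  apply Rmult_le_reg_r with (Rabs h0); [apply Rabs_pos_lt; auto|].
  unfold Rdiv at 1. rewrite Rmult_assoc, Rinv_l, Rmult_1_r by (apply Rabs_no_R0; auto).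
  destruct (Rle_dec 0 h0).
  - rewrite (Rabs_right h0) in * by lra.
    assert (Hn : Rabs (h (c + h0) - h c - F c * (c + h0 - c)) <= eps / 2 * (c + h0 - c)).
    { apply (abs_cont_increment_near h F c (c + h0) E); try lra.
      - apply (abs_cont_on_restrict h a b); auto; lra.
      - exact HE.
      - intros; apply Hd; auto; lra.
      - intros t Ht. apply HFd; [lra|]. apply Rabs_def1; lra. }
    replace (c + h0 - c) with h0 in Hn by ring. exact Hn.
  - rewrite (Rabs_left h0) in * by lra.
    assert (Hn : Rabs (h c - h (c + h0) - F c * (c - (c + h0))) <= eps / 2 * (c - (c + h0))).
    { apply (abs_cont_increment_near h F (c + h0) c E); try lra.
      - apply (abs_cont_on_restrict h a b); auto; lra.
      - exact HE.
      - intros; apply Hd; auto; lra.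
      - intros t Ht. apply HFd; [lra|]. apply Rabs_def1; lra. }
    replace (h (c + h0) - h c - F c * h0) with (- (h c - h (c + h0) - F c * (c - (c + h0)))) by ring.
    rewrite Rabs_Ropp. replace (- h0) with (c - (c + h0)) by ring. exact Hn.
Qed.

(** * Compactness and Gronwall's inequality *)

Lemma inv_succ_lt eps : 0 < eps -> exists N : nat, forall n, (N <= n)%nat -> / (INR n + 1) < eps.
Proof.
  intro He. destruct (INR_unbounded (/ eps)) as [N HN]. exists N. intros n Hn. apply le_INR in Hn.
  pose proof (Rinv_0_lt_compat _ He). rewrite <- (Rinv_inv eps).
  apply Rinv_lt_contravar; [apply Rmult_lt_0_compat|]; lra.
Qed.

Lemma strict_incr_ge_id (psi : nat -> nat) : (forall n, (psi n < psi (S n))%nat) -> forall n, (n <= psi n)%nat.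
Proof. intros H n; induction n as [|n IH]; [lia|]. specialize (H n). lia. Qed.

Lemma strict_incr_le (psi : nat -> nat) :
  (forall n, (psi n < psi (S n))%nat) -> forall n m, (n <= m)%nat -> (psi n <= psi m)%nat.
Proof. intros H n m Hnm; induction Hnm as [|m _ IH]; [lia|]. specialize (H m). lia. Qed.

Lemma strict_incr_comp (phi psi : nat -> nat) : (forall n, (phi n < phi (S n))%nat) ->
  (forall n, (psi n < psi (S n))%nat) -> forall n, (phi (psi n) < phi (psi (S n)))%nat.
Proof.
  intros Hphi Hpsi n. pose proof (strict_incr_le phi Hphi (S (psi n)) (psi (S n)) (Hpsi n)).
  specialize (Hphi (psi n)). lia.
Qed.

Lemma Un_cv_subseq u L (psi : nat -> nat) :
  Un_cv u L -> (forall n, (psi n < psi (S n))%nat) -> Un_cv (fun n => u (psi n)) L.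
Proof.
  intros Hu Hp eps He. destruct (Hu eps He) as [N HN]. exists N. intros n Hn. apply HN.
  pose proof (strict_incr_ge_id psi Hp n). lia.
Qed.

Lemma bolzano_weierstrass_subseq (u : nat -> R) B : (forall n, Rabs (u n) <= B) ->
  exists phi : nat -> nat, (forall n, (phi n < phi (S n))%nat) /\ exists l, Un_cv (fun n => u (phi n)) l.
Proof.
  intro HB. destruct (Bolzano_Weierstrass u (fun c => -B <= c <= B) (compact_P3 (-B) B)) as [l Hl].
  { intro n. apply Rabs_le_inv, HB. }
  assert (H : forall N k : nat, exists p, (N <= p)%nat /\ Rabs (u p - l) < / (INR k + 1)).
  { intros N k. assert (Hpos : 0 < / (INR k + 1)) by (apply Rinv_0_lt_compat; pose proof (pos_INR k); lra).
    destruct (Hl (disc l (mkposreal _ Hpos)) N) as [p [Hp1 Hp2]].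
    - exists (mkposreal _ Hpos). intros x Hx; auto.
    - exists p. split; auto. }
  set (sel := fun N k => proj1_sig (constructive_indefinite_description _ (H N k))).
  assert (Hsel : forall N k, (N <= sel N k)%nat /\ Rabs (u (sel N k) - l) < / (INR k + 1))
    by (intros N k; unfold sel; destruct (constructive_indefinite_description _ (H N k)); auto).
  set (phi := fix f n := match n with O => sel O O | S m => sel (S (f m)) (S m) end).
  exists phi. split; [intro n; simpl; apply (Hsel (S (phi n)) (S n))|].
  exists l. intros eps He. destruct (inv_succ_lt eps He) as [N HN]. exists N. intros n Hn. unfold Rdist.
  apply Rlt_trans with (/ (INR n + 1)); auto.
  destruct n; simpl; [apply (Hsel O O)|apply (Hsel (S (phi n)) (S n))].
Qed.

Lemma bolzano_weierstrass_list {I : Type} (l : list I) (y : nat -> I -> R) B :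
  (forall n i, Rabs (y n i) <= B) ->
  exists phi : nat -> nat, (forall n, (phi n < phi (S n))%nat) /\
    forall i, In i l -> exists L, Un_cv (fun n => y (phi n) i) L.
Proof.
  intro HB. induction l as [|i0 l [phi1 [Hp1 Hc1]]].
  - exists (fun n => n). split; [intro; lia|]. intros i [].
  - destruct (bolzano_weierstrass_subseq (fun n => y (phi1 n) i0) B) as [phi2 [Hp2 [L0 HL0]]];
      [intro; apply HB|].
    exists (fun n => phi1 (phi2 n)). split; [apply strict_incr_comp; auto|].
    intros i [Hi|Hi]; [subst; exists L0; auto|].
    destruct (Hc1 i Hi) as [L HL]. exists L. apply (Un_cv_subseq (fun n => y (phi1 n) i) L phi2); auto.
Qed.

Fixpoint fin_list (n : nat) : list (Fin.t n) :=
  match n with O => nil | S m => Fin.F1 :: map Fin.FS (fin_list m) end.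

Lemma fin_list_in n (i : Fin.t n) : In i (fin_list n).
Proof. induction i; simpl; [auto|]. right. apply in_map. auto. Qed.

Lemma bolzano_weierstrass_vec n (y : nat -> Vec n) B : (forall m k, Rabs (y m k) <= B) ->
  exists phi : nat -> nat, (forall m, (phi m < phi (S m))%nat) /\
    exists p : Vec n, Un_cv (fun m => vnorm (vsub (y (phi m)) p)) 0.
Proof.
  intro HB. destruct (bolzano_weierstrass_list (fin_list n) y B HB) as [phi [Hphi Hc]].
  assert (H : forall k, exists L, Un_cv (fun m => y (phi m) k) L) by (intro k; apply Hc, fin_list_in).
  set (p := fun k => proj1_sig (constructive_indefinite_description _ (H k))).
  assert (Hp : forall k, Un_cv (fun m => y (phi m) k) (p k))
    by (intro k; unfold p; destruct (constructive_indefinite_description _ (H k)); auto).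
  exists phi. split; auto. exists p.
  rewrite <- (fsum_zero n (fun _ => 0)) by auto.
  apply (Un_cv_fsum n (fun m k => Rabs (y (phi m) k - p k))). intro k.
  intros eps He. destruct (Hp k eps He) as [N HN]. exists N. intros m Hm. specialize (HN m Hm).
  unfold Rdist in *. rewrite Rminus_0_r, Rabs_Rabsolu. auto.
Qed.

Lemma vnorm_continuous_of_derivable n (e : R -> Vec n) c (g : Vec n) :
  (forall k, derivable_pt_lim (fun s => e s k) c (g k)) ->
  forall eps, 0 < eps -> exists del, 0 < del /\
    forall s, Rabs (s - c) < del -> Rabs (vnorm (e s) - vnorm (e c)) <= eps.
Proof.
  intros Hd. apply (fsum_near n (fun k s => Rabs (e s k)) (fun del s => Rabs (s - c) < del) c).
  - intros d d' s Hd' Hs. lra.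
  - intros k eps He. destruct (derivable_pt_lim_near _ c (g k) (Hd k) eps He) as [del [Hdel H]].
    exists del. split; auto. intros s Hs. eapply Rle_lt_trans; [apply Rabs_triang_inv2|]. auto.
Qed.

Lemma vnorm_left_increment_le n (e : R -> Vec n) (g : Vec n) c eps :
  (forall k, derivable_pt_lim (fun s => e s k) c (g k)) -> 0 < eps ->
  exists del, 0 < del /\ forall s, c - del < s < c -> vnorm (e c) - vnorm (e s) <= (vnorm g + eps) * (c - s).
Proof.
  intros Hd He. pose proof (pos_INR n) as Hn. set (ep := eps / (INR n + 1)).
  assert (Hep : 0 < ep) by (apply Rdiv_lt_0_compat; lra).
  destruct (fin_common_radius n (fun k del => forall s, c - del < s < c ->
              Rabs (e c k - e s k) <= (Rabs (g k) + ep) * (c - s))) as [del [Hdel H]].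
  - intros k d d' Hd' Hp s Hs. apply Hp. lra.
  - intro k. apply (Rabs_left_increment_le (fun s => e s k) c (g k) ep (Hd k) Hep).
  - exists del. split; auto. intros s Hs. unfold vnorm. rewrite <- fsum_minus.
    apply Rle_trans with (fsum n (fun k => (Rabs (g k) + ep) * (c - s))).
    + apply fsum_le. intro k. eapply Rle_trans; [apply Rabs_triang_inv|apply (H k s Hs)].
    + rewrite (fsum_ext n _ (fun k => (c - s) * Rabs (g k) + (c - s) * ep)) by (intros k; ring).
      rewrite fsum_plus, fsum_scal, fsum_const.
      assert (INR n * ep <= eps).
      { unfold ep. apply Rmult_le_reg_r with (INR n + 1); [lra|].
        replace (INR n * (eps / (INR n + 1)) * (INR n + 1)) with (INR n * eps) by (field; lra). nra. }
      unfold vnorm. nra.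
Qed.

Section Gronwall.
Variables (n : nat) (a b da db : R -> Vec n) (T L beta del : R).
Hypotheses (HT : 0 <= T) (HL : 0 < L) (Hdel : 0 < del) (Hbeta : 0 <= beta).
Hypothesis Hd : forall t, 0 <= t <= T -> forall k,
  derivable_pt_lim (fun s => a s k) t (da t k) /\ derivable_pt_lim (fun s => b s k) t (db t k).
Hypothesis Hlip : forall t, 0 <= t <= T -> vnorm (vsub (da t) (db t)) <= L * vnorm (vsub (a t) (b t)) + L * beta.

Let D t := vnorm (vsub (a t) (b t)).
Let C := D 0 + del.
Let K := L * beta + del.
(* Phi' >= L * Phi + K: the comparison function outgrows the differential inequality for D. *)
Let Phi t := (C + K * t) * exp (L * t).
Let dPhi t := K * exp (L * t) + (C + K * t) * (exp (L * t) * L).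

Lemma gronwall_dPhi c : derivable_pt_lim Phi c (dPhi c).
Proof.
  assert (Hlin : forall M, derivable_pt_lim (fun t => M * t) c M)
    by (intro M; apply (derivable_pt_lim_eq_ext (mult_real_fct M id) (fun t => M * t) c (M * 1) M);
        [intro; reflexivity|ring|apply derivable_pt_lim_scal, derivable_pt_lim_id]).
  apply (derivable_pt_lim_mult (fun t => C + K * t) (fun t => exp (L * t))).
  - replace K with (0 + K) at 1 by ring. apply derivable_pt_lim_plus; [apply derivable_pt_lim_const|apply Hlin].
  - apply (derivable_pt_lim_comp (fun t => L * t) exp); [apply Hlin|apply derivable_pt_lim_exp].
Qed.

Lemma gronwall_dist_derivable t : 0 <= t <= T ->
  forall k, derivable_pt_lim (fun s => vsub (a s) (b s) k) t (vsub (da t) (db t) k).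
Proof. intros Ht k. apply derivable_pt_lim_minus; apply Hd; auto. Qed.

Lemma gronwall_gap_continuous c : 0 <= c <= T -> forall eps, 0 < eps -> exists e, 0 < e /\
  forall s, Rabs (s - c) < e -> Rabs ((D s - Phi s) - (D c - Phi c)) < eps.
Proof.
  intros Hc eps Heps.
  destruct (vnorm_continuous_of_derivable n (fun s => vsub (a s) (b s)) c _ (gronwall_dist_derivable c Hc) (eps/2))
    as [e1 [He1 H1]]; [lra|].
  destruct (derivable_pt_lim_near Phi c _ (gronwall_dPhi c) (eps/2)) as [e2 [He2 H2]]; [lra|].
  exists (Rmin e1 e2). split; [apply Rmin_pos; auto|]. intros s Hs.
  pose proof (Rmin_l e1 e2). pose proof (Rmin_r e1 e2).
  specialize (H1 s ltac:(lra)). specialize (H2 s ltac:(lra)).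
  replace (D s - Phi s - (D c - Phi c)) with ((D s - D c) - (Phi s - Phi c)) by ring.
  eapply Rle_lt_trans; [apply Rabs_triang|]. rewrite Rabs_Ropp. unfold D. lra.
Qed.

Lemma gronwall_no_contact c : 0 < c <= T -> (forall s, 0 <= s < c -> D s < Phi s) -> D c <> Phi c.
Proof.
  intros Hc Hq Heq. set (g := vsub (da c) (db c)).
  destruct (vnorm_left_increment_le n (fun s => vsub (a s) (b s)) g c (del/3)
              (gronwall_dist_derivable c ltac:(lra)) ltac:(lra)) as [e1 [He1 H1]].
  destruct (derivable_pt_lim_left_le (fun s => - Phi s) c _ (del/3)
              (derivable_pt_lim_opp _ _ _ (gronwall_dPhi c)) ltac:(lra)) as [e2 [He2 H2]].
  assert (Hm : 0 < Rmin e1 e2) by (apply Rmin_pos; auto).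
  pose proof (Rmin_l e1 e2). pose proof (Rmin_r e1 e2).
  pose proof (Rmax_l 0 (c - Rmin e1 e2 / 2)). pose proof (Rmax_r 0 (c - Rmin e1 e2 / 2)).
  set (s := Rmax 0 (c - Rmin e1 e2 / 2)) in *. assert (s < c) by (apply Rmax_lub_lt; lra).
  specialize (H1 s ltac:(lra)). specialize (H2 s ltac:(lra)). specialize (Hq s ltac:(lra)).
  fold (D c) (D s) in H1.
  assert (Hg : vnorm g <= L * D c + L * beta) by (apply Hlip; lra).
  assert (Hex : 1 <= exp (L * c)) by (pose proof (exp_ineq1_le (L * c)); nra).
  assert (HK : 0 <= K) by (unfold K; nra).
  assert (HdPhi : dPhi c >= K + L * Phi c) by (unfold dPhi, Phi; nra).
  assert (dPhi c - del/3 <= vnorm g + del/3); [|unfold K in *; nra].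
  apply Rmult_le_reg_r with (c - s); [lra|]. simpl in H2. lra.
Qed.

Lemma gronwall_vec t : 0 <= t <= T -> vnorm (vsub (a t) (b t)) <=
  (vnorm (vsub (a 0) (b 0)) + del + (L * beta + del) * t) * exp (L * t).
Proof.
  intro Ht. left. apply (real_induction 0 T (fun s => D s < Phi s) HT); auto.
  - unfold Phi, C. rewrite Rmult_0_r, Rmult_0_r, exp_0. lra.
  - intros c Hc Hq. destruct (gronwall_gap_continuous c ltac:(lra) ((Phi c - D c)/2)) as [e [He H]]; [lra|].
    exists e. split; auto. intros s Hs _. specialize (H s ltac:(rewrite Rabs_right; lra)).
    apply Rabs_def2 in H. lra.
  - intros c Hc Hq. assert (Hle : D c <= Phi c).
    { apply Rnot_lt_le. intro Hgt.
      destruct (gronwall_gap_continuous c ltac:(lra) ((D c - Phi c)/2)) as [e [He H]]; [lra|].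
      pose proof (Rmax_l 0 (c - e/2)). pose proof (Rmax_r 0 (c - e/2)).
      set (s := Rmax 0 (c - e/2)) in *. assert (s < c) by (apply Rmax_lub_lt; lra).
      specialize (Hq s ltac:(lra)). specialize (H s ltac:(apply Rabs_def1; lra)).
      apply Rabs_def2 in H. lra. }
    destruct Hle as [|Heq]; auto. exfalso. apply (gronwall_no_contact c); auto.
Qed.
End Gronwall.

(** * C1 functions and positive lower bounds *)

Lemma difference_quotient_near n (y : R -> Vec n) (v : Vec n) c :
  (forall k, derivable_pt_lim (fun t => y t k) c (v k)) -> forall eps, 0 < eps -> exists d, 0 < d /\
  forall h, h <> 0 -> Rabs h < d -> vnorm (vsub (fun k => (y (c + h) k - y c k) / h) v) <= eps.
Proof.
  intros Hy eps He. pose proof (pos_INR n) as Hn. set (e := eps / (INR n + 1)).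
  assert (He' : 0 < e) by (apply Rdiv_lt_0_compat; lra).
  destruct (fin_common_radius n (fun k d => forall h, h <> 0 -> Rabs h < d ->
              Rabs ((y (c + h) k - y c k) / h - v k) < e)) as [d [Hd H]].
  - intros k d d' Hd' Hp h H0 H1. apply Hp; auto; lra.
  - intro k. destruct (Hy k e He') as [del Hdel]. exists del. split; [apply cond_pos|]. intros; apply Hdel; auto.
  - exists d. split; auto. intros h H0 H1.
    apply Rle_trans with (INR n * e); [apply vnorm_le_coord_bound; intro k; left; apply H; auto|].
    unfold e. apply Rmult_le_reg_r with (INR n + 1); [lra|].
    replace (INR n * (eps / (INR n + 1)) * (INR n + 1)) with (INR n * eps) by (field; lra). nra.
Qed.

Lemma C1_quotient_remainder n (V : Vec n -> R) (g x q : Vec n) h e1 d1 :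
  (forall y, vnorm (vsub y x) < d1 -> Rabs (V y - V x - vdot g (vsub y x)) <= e1 * vnorm (vsub y x)) ->
  h <> 0 -> Rabs h * vnorm q < d1 ->
  Rabs ((V (fun k => x k + h * q k) - V x) / h - vdot g q) <= e1 * vnorm q.
Proof.
  intros HV Hh Hsm.
  assert (Hd : vsub (fun k => x k + h * q k) x = fun k => h * q k)
    by (apply functional_extensionality; intro k; unfold vsub; ring).
  assert (Hnd : vnorm (vsub (fun k => x k + h * q k) x) = Rabs h * vnorm q)
    by (rewrite Hd; unfold vnorm; rewrite <- fsum_scal; apply fsum_ext; intro; apply Rabs_mult).
  assert (Hdot : vdot g (vsub (fun k => x k + h * q k) x) = h * vdot g q)
    by (rewrite Hd; unfold vdot; rewrite <- fsum_scal; apply fsum_ext; intro; ring).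
  rewrite <- Hnd in Hsm. specialize (HV _ Hsm). rewrite Hnd, Hdot in HV.
  replace ((V (fun k => x k + h * q k) - V x) / h - vdot g q) with
    ((V (fun k => x k + h * q k) - V x - h * vdot g q) / h) by (field; auto).
  unfold Rdiv. rewrite Rabs_mult, Rabs_inv. apply Rmult_le_reg_r with (Rabs h); [apply Rabs_pos_lt; auto|].
  rewrite Rmult_assoc, Rinv_l by (apply Rabs_no_R0; auto). nra.
Qed.

Lemma C1_chain_rule n (V : Vec n -> R) (G : Vec n -> Vec n) (y : R -> Vec n) (v : Vec n) c :
  C1_with_grad V G -> (forall k, derivable_pt_lim (fun t => y t k) c (v k)) ->
  derivable_pt_lim (fun t => V (y t)) c (vdot (G (y c)) v).
Proof.
  intros [HV _] Hy eps He. set (x := y c). set (g := G x).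
  pose proof (vnorm_nonneg n g) as Hg0. pose proof (vnorm_nonneg n v) as Hv0.
  pose proof (Rmin_l 1 (eps / (2 * (vnorm g + 1)))). pose proof (Rmin_r 1 (eps / (2 * (vnorm g + 1)))).
  set (r := Rmin 1 (eps / (2 * (vnorm g + 1)))) in *.
  assert (Hr : 0 < r) by (apply Rmin_pos; [lra|apply Rdiv_lt_0_compat; lra]).
  destruct (difference_quotient_near n y v c Hy r Hr) as [d2 [Hd2 H2]].
  set (e1 := eps / (2 * (vnorm v + 1))). assert (He1 : 0 < e1) by (apply Rdiv_lt_0_compat; lra).
  destruct (HV x e1 He1) as [d1 [Hd1 H1]].
  assert (Hp : 0 < Rmin d2 (d1 / (vnorm v + 1))) by (apply Rmin_pos; auto; apply Rdiv_lt_0_compat; lra).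
  exists (mkposreal _ Hp). simpl. intros h Hh Hlt.
  pose proof (Rmin_l d2 (d1 / (vnorm v + 1))). pose proof (Rmin_r d2 (d1 / (vnorm v + 1))).
  set (q := fun k => (y (c + h) k - y c k) / h).
  assert (Hq : vnorm (vsub q v) <= r) by (apply H2; auto; lra).
  assert (Hqn : vnorm q <= vnorm v + 1) by (pose proof (vnorm_le_vsub n q v); lra).
  assert (Hyq : y (c + h) = fun k => x k + h * q k)
    by (apply functional_extensionality; intro k; unfold q, x; field; auto).
  assert (A1 : Rabs ((V (y (c + h)) - V x) / h - vdot g q) <= e1 * vnorm q).
  { rewrite Hyq. apply C1_quotient_remainder with d1; auto.
    apply Rle_lt_trans with (Rabs h * (vnorm v + 1)); [apply Rmult_le_compat_l; auto; apply Rabs_pos|].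
    apply Rlt_le_trans with (d1 / (vnorm v + 1) * (vnorm v + 1)); [apply Rmult_lt_compat_r; lra|].
    right; field; lra. }
  assert (A2 : Rabs (vdot g q - vdot g v) <= vnorm g * vnorm (vsub q v))
    by (rewrite vdot_minus; apply Rabs_vdot_le).
  replace ((V (y (c + h)) - V x) / h - vdot g v) with
    (((V (y (c + h)) - V x) / h - vdot g q) + (vdot g q - vdot g v)) by ring.
  eapply Rle_lt_trans; [apply Rabs_triang|].
  assert (e1 * vnorm q <= eps / 2).
  { apply Rle_trans with (e1 * (vnorm v + 1)); [apply Rmult_le_compat_l; lra|]. unfold e1. right; field; lra. }
  assert (vnorm g * vnorm (vsub q v) < eps / 2).
  { apply Rle_lt_trans with (vnorm g * (eps / (2 * (vnorm g + 1)))); [apply Rmult_le_compat_l; lra|].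
    apply Rmult_lt_reg_r with (2 * (vnorm g + 1)); [lra|].
    replace (vnorm g * (eps / (2 * (vnorm g + 1))) * (2 * (vnorm g + 1))) with (vnorm g * eps) by (field; lra). nra. }
  lra.
Qed.

Lemma C1_continuous n (V : Vec n -> R) G : C1_with_grad V G -> forall p eps, 0 < eps -> exists d, 0 < d /\
  forall y, vnorm (vsub y p) < d -> Rabs (V y - V p) < eps.
Proof.
  intros [H1 _] p eps He. pose proof (vnorm_nonneg n (G p)).
  destruct (H1 p 1 ltac:(lra)) as [d [Hd Hd']].
  set (d' := eps / (vnorm (G p) + 2)). assert (0 < d') by (apply Rdiv_lt_0_compat; lra).
  exists (Rmin d d'). split; [apply Rmin_pos; auto|].
  intros y Hy. pose proof (Rmin_l d d'). pose proof (Rmin_r d d').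
  specialize (Hd' y ltac:(lra)). pose proof (Rabs_vdot_le n (G p) (vsub y p)). pose proof (vnorm_nonneg n (vsub y p)).
  assert (Rabs (V y - V p) <= (vnorm (G p) + 1) * vnorm (vsub y p)).
  { replace (V y - V p) with ((V y - V p - vdot (G p) (vsub y p)) + vdot (G p) (vsub y p)) by ring.
    eapply Rle_trans; [apply Rabs_triang|]. lra. }
  assert ((vnorm (G p) + 1) * vnorm (vsub y p) < eps); [|lra].
  apply Rle_lt_trans with ((vnorm (G p) + 1) * d'); [apply Rmult_le_compat_l; lra|].
  apply Rmult_lt_reg_r with (vnorm (G p) + 2); [lra|].
  unfold d'. replace ((vnorm (G p) + 1) * (eps / (vnorm (G p) + 2)) * (vnorm (G p) + 2)) with ((vnorm (G p) + 1) * eps)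
    by (field; lra). nra.
Qed.

Definition jointly_continuous {n} (P : Vec n -> R -> R) : Prop :=
  forall p u0 eps, 0 < eps -> exists del, 0 < del /\
    forall y u, vnorm (vsub y p) < del -> Rabs (u - u0) < del -> Rabs (P y u - P p u0) < eps.

Lemma no_pos_lower_bound_seq {A : Type} (S : A -> Prop) (P : A -> R) :
  ~ (exists m, 0 < m /\ forall a, S a -> m <= P a) ->
  exists s : nat -> A, forall k, S (s k) /\ P (s k) < / (INR k + 1).
Proof.
  intro Hn.
  assert (H : forall k : nat, exists a, S a /\ P a < / (INR k + 1)).
  { intro k. apply NNPP. intro Hk. apply Hn. exists (/ (INR k + 1)).
    split; [apply Rinv_0_lt_compat; pose proof (pos_INR k); lra|].
    intros a Ha. apply Rnot_lt_le. intro Hlt. apply Hk. exists a; auto. }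
  exists (fun k => proj1_sig (constructive_indefinite_description _ (H k))).
  intro k. destruct (constructive_indefinite_description _ (H k)); auto.
Qed.

Lemma Un_cv_vnorm_between n (y : nat -> Vec n) (p x : Vec n) lo hi :
  Un_cv (fun m => vnorm (vsub (y m) p)) 0 -> (forall m, lo <= vnorm (vsub (y m) x) <= hi) ->
  lo <= vnorm (vsub p x) <= hi.
Proof.
  intros Hp Hy. split; apply Rnot_lt_le; intro Hlt.
  - destruct (Hp (lo - vnorm (vsub p x)) ltac:(lra)) as [N HN]. specialize (HN N (le_n N)). unfold Rdist in HN.
    rewrite Rminus_0_r, Rabs_right in HN by (apply Rle_ge, vnorm_nonneg).
    pose proof (vnorm_vsub_triang n (y N) p x). specialize (Hy N). lra.
  - destruct (Hp (vnorm (vsub p x) - hi) ltac:(lra)) as [N HN]. specialize (HN N (le_n N)). unfold Rdist in HN.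
    rewrite Rminus_0_r, Rabs_right in HN by (apply Rle_ge, vnorm_nonneg).
    pose proof (vnorm_vsub_triang n p (y N) x). rewrite (vnorm_vsub_sym n p (y N)) in *. specialize (Hy N). lra.
Qed.

Lemma Un_cv_Rabs_between (u : nat -> R) u0 lo hi :
  Un_cv u u0 -> (forall m, lo <= Rabs (u m) <= hi) -> lo <= Rabs u0 <= hi.
Proof.
  intros Hu Hb. split; apply Rnot_lt_le; intro Hlt.
  - destruct (Hu (lo - Rabs u0) ltac:(lra)) as [N HN]. specialize (HN N (le_n N)). unfold Rdist in HN.
    specialize (Hb N). pose proof (Rabs_triang_inv (u N) u0). lra.
  - destruct (Hu (Rabs u0 - hi) ltac:(lra)) as [N HN]. specialize (HN N (le_n N)). unfold Rdist in HN.
    specialize (Hb N). pose proof (Rabs_triang_inv u0 (u N)). rewrite Rabs_minus_sym in HN. lra.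
Qed.

Lemma continuous_pos_lower_bound n (P : Vec n -> R -> R) x ry0 ry1 ru0 ru1 :
  jointly_continuous P ->
  (forall y u, ry0 <= vnorm (vsub y x) <= ry1 -> ru0 <= Rabs u <= ru1 -> 0 < P y u) ->
  exists m, 0 < m /\ forall y u, ry0 <= vnorm (vsub y x) <= ry1 -> ru0 <= Rabs u <= ru1 -> m <= P y u.
Proof.
  intros HP Hpos. apply NNPP. intro Hn.
  destruct (no_pos_lower_bound_seq (fun yu : Vec n * R => ry0 <= vnorm (vsub (fst yu) x) <= ry1 /\
              ru0 <= Rabs (snd yu) <= ru1) (fun yu => P (fst yu) (snd yu))) as [yu Hyu].
  { intros [m [Hm Hm']]. apply Hn. exists m. split; auto. intros y u Hy Hu. apply (Hm' (y, u)). simpl; auto. }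
  destruct (bolzano_weierstrass_subseq (fun k => snd (yu k)) ru1) as [phi1 [Hphi1 [u0 Hu0]]];
    [intro k; apply Hyu|].
  destruct (bolzano_weierstrass_vec n (fun k => fst (yu (phi1 k))) (ry1 + vnorm x)) as [phi2 [Hphi2 [p Hp]]].
  { intros m k. destruct (Hyu (phi1 m)) as [[[_ H1] _] _].
    pose proof (Rabs_coord_le_vnorm n (vsub (fst (yu (phi1 m))) x) k). pose proof (Rabs_coord_le_vnorm n x k).
    replace (fst (yu (phi1 m)) k) with ((fst (yu (phi1 m)) k - x k) + x k) by ring.
    eapply Rle_trans; [apply Rabs_triang|]. unfold vsub in *. lra. }
  set (psi := fun m => phi1 (phi2 m)).
  assert (Hpsi : forall m, (psi m < psi (S m))%nat) by (intro m; unfold psi; apply strict_incr_comp; auto).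
  assert (Hu : Un_cv (fun m => snd (yu (psi m))) u0) by (apply (Un_cv_subseq (fun k => snd (yu (phi1 k))) u0 phi2); auto).
  assert (Hpr : ry0 <= vnorm (vsub p x) <= ry1)
    by (apply (Un_cv_vnorm_between n (fun m => fst (yu (psi m))) p x); auto; intro m; apply Hyu).
  assert (Hur : ru0 <= Rabs u0 <= ru1) by (apply (Un_cv_Rabs_between _ u0 ru0 ru1 Hu); intro m; apply Hyu).
  specialize (Hpos p u0 Hpr Hur). set (gap := P p u0) in *.
  destruct (HP p u0 (gap/2) ltac:(lra)) as [del [Hdel Hdel']].
  destruct (Hp del Hdel) as [N1 HN1]. destruct (Hu del Hdel) as [N3 HN3].
  destruct (inv_succ_lt (gap/2) ltac:(lra)) as [N2 HN2].
  set (m := Nat.max N1 (Nat.max N2 N3)).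
  specialize (HN1 m ltac:(unfold m; lia)). specialize (HN3 m ltac:(unfold m; lia)).
  specialize (HN2 (psi m) ltac:(pose proof (strict_incr_ge_id psi Hpsi m); unfold m in *; lia)).
  unfold Rdist in HN1, HN3. rewrite Rminus_0_r, Rabs_right in HN1 by (apply Rle_ge, vnorm_nonneg).
  specialize (Hdel' _ _ HN1 HN3). destruct (Hyu (psi m)) as [_ Hv]. cbv beta in Hv. apply Rabs_def2 in Hdel'.
  unfold psi, gap in *. lra.
Qed.

Lemma C1_strict_min_sphere_gap n (V : Vec n -> R) G x r d : C1_with_grad V G -> 0 < r -> r < d ->
  (forall y, 0 < vnorm (vsub y x) < d -> V x < V y) ->
  exists m, 0 < m /\ forall y, vnorm (vsub y x) = r -> m <= V y - V x.
Proof.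
  intros HC Hr Hrd Hmin.
  destruct (continuous_pos_lower_bound n (fun y _ => V y - V x) x r r 0 0) as [m [Hm Hm']].
  - intros p u0 eps He. destruct (C1_continuous n V G HC p eps He) as [del [Hdel H]].
    exists del. split; auto. intros y u Hy _. replace (V y - V x - (V p - V x)) with (V y - V p) by ring. auto.
  - intros y u Hy _. specialize (Hmin y ltac:(lra)). lra.
  - exists m. split; auto. intros y Hy. apply (Hm' y 0); [lra|rewrite Rabs_R0; lra].
Qed.

Lemma lipschitz_pos {n} (f : Vec n -> R -> Vec n) (g : Vec n -> R -> R) : globally_lipschitz f g ->
  exists L, 0 < L /\ forall x y u v,
    vnorm (vsub (f x u) (f y v)) <= L * (vnorm (vsub x y) + Rabs (u - v)) /\
    Rabs (g x u - g y v) <= L * (vnorm (vsub x y) + Rabs (u - v)).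
Proof.
  intros [L HL]. exists (Rabs L + 1). split; [pose proof (Rabs_pos L); lra|].
  intros. destruct (HL x y u v). pose proof (vnorm_nonneg _ (vsub x y)). pose proof (Rabs_pos (u - v)).
  pose proof (Rle_abs L). split; nra.
Qed.

Lemma jointly_continuous_minus n (P Q : Vec n -> R -> R) :
  jointly_continuous P -> jointly_continuous Q -> jointly_continuous (fun y u => P y u - Q y u).
Proof.
  intros HP HQ p u0 eps He.
  destruct (HP p u0 (eps/2) ltac:(lra)) as [d1 [Hd1 H1]]. destruct (HQ p u0 (eps/2) ltac:(lra)) as [d2 [Hd2 H2]].
  exists (Rmin d1 d2). split; [apply Rmin_pos; auto|]. intros y u Hy Hu.
  pose proof (Rmin_l d1 d2). pose proof (Rmin_r d1 d2).
  specialize (H1 y u ltac:(lra) ltac:(lra)). specialize (H2 y u ltac:(lra) ltac:(lra)).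
  replace (P y u - Q y u - (P p u0 - Q p u0)) with ((P y u - P p u0) - (Q y u - Q p u0)) by ring.
  eapply Rle_lt_trans; [apply Rabs_triang|]. rewrite Rabs_Ropp. lra.
Qed.

Lemma supply_rate_continuous n (g : Vec n -> R -> R) (f : Vec n -> R -> Vec n) s0 :
  globally_lipschitz f g -> jointly_continuous (fun y u => u * (g y u - s0)).
Proof.
  intros Hlip p u0 eps He. destruct (lipschitz_pos f g Hlip) as [L [HL HL']].
  set (C := Rabs (g p u0 - s0) + 2 * L). set (K := C + 2 * L * Rabs u0 + 1).
  pose proof (Rabs_pos (g p u0 - s0)). pose proof (Rabs_pos u0).
  assert (HK : 0 < K) by (unfold K, C; nra).
  pose proof (Rmin_l 1 (eps / K)). pose proof (Rmin_r 1 (eps / K)). set (del := Rmin 1 (eps / K)) in *.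
  assert (Hdel : 0 < del) by (apply Rmin_pos; [lra|apply Rdiv_lt_0_compat; lra]).
  exists del. split; auto. intros y u Hy Hu.
  destruct (HL' y p u u0) as [_ Hg].
  assert (Hgd : Rabs (g y u - g p u0) <= 2 * L * del) by nra.
  assert (Hgg : Rabs (g y u - s0) <= C).
  { replace (g y u - s0) with ((g y u - g p u0) + (g p u0 - s0)) by ring.
    eapply Rle_trans; [apply Rabs_triang|]. unfold C. nra. }
  replace (u * (g y u - s0) - u0 * (g p u0 - s0)) with ((u - u0) * (g y u - s0) + u0 * (g y u - g p u0)) by ring.
  eapply Rle_lt_trans; [apply Rabs_triang|]. rewrite !Rabs_mult.
  assert (Rabs (u - u0) * Rabs (g y u - s0) <= del * C) by (apply Rmult_le_compat; try apply Rabs_pos; lra).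
  assert (Rabs u0 * Rabs (g y u - g p u0) <= Rabs u0 * (2 * L * del)) by (apply Rmult_le_compat_l; lra).
  assert (del * K <= eps / K * K) by (apply Rmult_le_compat_r; lra).
  replace (eps / K * K) with eps in * by (field; lra). unfold K in *. nra.
Qed.

Lemma storage_rate_continuous n (g : Vec n -> R -> R) (f : Vec n -> R -> Vec n) (G : Vec n -> Vec n) :
  globally_lipschitz f g ->
  (forall x eps, 0 < eps -> exists d, 0 < d /\ forall y, vnorm (vsub y x) < d -> vnorm (vsub (G y) (G x)) < eps) ->
  jointly_continuous (fun y u => vdot (G y) (f y u)).
Proof.
  intros Hlip HG p u0 eps He. destruct (lipschitz_pos f g Hlip) as [L [HL HL']].
  pose proof (vnorm_nonneg n (f p u0)). pose proof (vnorm_nonneg n (G p)).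
  set (A := vnorm (f p u0)) in *. set (Gp := vnorm (G p)) in *.
  set (eta := eps / (2 * (A + 2 * L + 1))). assert (Heta : 0 < eta) by (apply Rdiv_lt_0_compat; lra).
  destruct (HG p eta Heta) as [dG [HdG HdG']].
  pose proof (Rmin_l 1 (Rmin dG (eps / (4 * L * (Gp + 1))))). pose proof (Rmin_r 1 (Rmin dG (eps / (4 * L * (Gp + 1))))).
  pose proof (Rmin_l dG (eps / (4 * L * (Gp + 1)))). pose proof (Rmin_r dG (eps / (4 * L * (Gp + 1)))).
  set (del := Rmin 1 (Rmin dG (eps / (4 * L * (Gp + 1))))) in *.
  assert (Hdel : 0 < del)
    by (unfold del; repeat apply Rmin_pos; try lra; apply Rdiv_lt_0_compat; nra).
  exists del. split; auto. intros y u Hy Hu.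
  destruct (HL' y p u u0) as [Hf _].
  assert (Hfd : vnorm (vsub (f y u) (f p u0)) <= 2 * L * del) by nra.
  assert (Hfy : vnorm (f y u) <= A + 2 * L) by (pose proof (vnorm_le_vsub n (f y u) (f p u0)); unfold A; nra).
  specialize (HdG' y ltac:(lra)).
  rewrite vdot_minus_split. eapply Rle_lt_trans; [apply Rabs_triang|].
  pose proof (Rabs_vdot_le n (vsub (G y) (G p)) (f y u)). pose proof (Rabs_vdot_le n (G p) (vsub (f y u) (f p u0))).
  pose proof (vnorm_nonneg n (vsub (G y) (G p))). pose proof (vnorm_nonneg n (f y u)).
  assert (T1 : vnorm (vsub (G y) (G p)) * vnorm (f y u) <= eta * (A + 2 * L)) by (apply Rmult_le_compat; lra).
  assert (T2 : Gp * vnorm (vsub (f y u) (f p u0)) <= Gp * (2 * L * del)) by (apply Rmult_le_compat_l; lra).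
  assert (T3 : eta * (A + 2 * L) < eps / 2).
  { unfold eta. apply Rmult_lt_reg_r with (2 * (A + 2 * L + 1)); [lra|].
    replace (eps / (2 * (A + 2 * L + 1)) * (A + 2 * L) * (2 * (A + 2 * L + 1))) with (eps * (A + 2 * L)) by (field; lra).
    nra. }
  assert (T4 : Gp * (2 * L * del) <= eps / 2).
  { apply Rle_trans with (Gp * (2 * L * (eps / (4 * L * (Gp + 1))))); [apply Rmult_le_compat_l; nra|].
    replace (Gp * (2 * L * (eps / (4 * L * (Gp + 1))))) with (eps / 2 * (Gp / (Gp + 1))) by (field; lra).
    assert (Gp / (Gp + 1) <= 1) by (apply Rmult_le_reg_r with (Gp + 1); [lra|]; unfold Rdiv;
      rewrite Rmult_assoc, Rinv_l by lra; lra).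
    nra. }
  unfold Gp in *. lra.
Qed.

(** * The network model *)

Definition edge_sum_at {ne nn} (f : Fin.t ne -> Fin.t nn) (q : Fin.t ne -> R) (j : Fin.t nn) : R :=
  fsum ne (fun e => if Fin.eq_dec (f e) j then q e else 0).

Lemma edge_sum_at_minus {ne nn} (f : Fin.t ne -> Fin.t nn) q q' j :
  edge_sum_at f q j - edge_sum_at f q' j = edge_sum_at f (fun e => q e - q' e) j.
Proof. unfold edge_sum_at. rewrite <- fsum_minus. apply fsum_ext. intro e. destruct (Fin.eq_dec (f e) j); ring. Qed.

Lemma Rabs_edge_sum_at_le {ne nn} (f : Fin.t ne -> Fin.t nn) q (c : Fin.t ne -> R) j :
  (forall e, Rabs (q e) <= c e) -> Rabs (edge_sum_at f q j) <= fsum ne c.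
Proof.
  intro H. eapply Rle_trans; [apply Rabs_fsum|]. apply fsum_le. intro e.
  destruct (Fin.eq_dec (f e) j); [apply H|]. rewrite Rabs_R0. pose proof (Rabs_pos (q e)). specialize (H e). lra.
Qed.

Section Network.
Variable Nw : Net.

Inductive coord : Type :=
  | CE (e : Fin.t (nE Nw))
  | CO (j : Fin.t (nN Nw))
  | CX (j : Fin.t (nN Nw)) (k : Fin.t (nd Nw j)).

Definition coord_val (x : state Nw) (c : coord) : R :=
  match c with CE e => eta x e | CO j => om x j | CX j k => xs x j k end.

Definition of_coords (f : coord -> R) : state Nw :=
  mkState (fun e => f (CE e)) (fun j => f (CO j)) (fun j k => f (CX j k)).

Lemma coord_val_of_coords f c : coord_val (of_coords f) c = f c.
Proof. destruct c; reflexivity. Qed.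

Definition coord_list : list coord :=
  map CE (fin_list _) ++ map CO (fin_list _) ++ flat_map (fun j => map (CX j) (fin_list _)) (fin_list _).

Lemma coord_list_in c : In c coord_list.
Proof.
  unfold coord_list. destruct c; apply in_or_app.
  - left. apply in_map, fin_list_in.
  - right. apply in_or_app. left. apply in_map, fin_list_in.
  - right. apply in_or_app. right. apply in_flat_map. exists j. split; [apply fin_list_in|apply in_map, fin_list_in].
Qed.

Lemma coord_common_radius (P : coord -> R -> Prop) :
  (forall c d d', 0 < d' <= d -> P c d -> P c d') -> (forall c, exists d, 0 < d /\ P c d) ->
  exists d, 0 < d /\ forall c, P c d.
Proof.
  intros Hm H.
  destruct (fin_common_radius _ (fun e => P (CE e))) as [d1 [H1 H1']]; [intros; eapply Hm; eauto|intro; apply H|].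
  destruct (fin_common_radius _ (fun j => P (CO j))) as [d2 [H2 H2']]; [intros; eapply Hm; eauto|intro; apply H|].
  destruct (fin_common_radius _ (fun j d => forall k, P (CX j k) d)) as [d3 [H3 H3']].
  { intros i d d' Hd Hp k; eapply Hm; eauto. }
  { intro j. apply (fin_common_radius _ (fun k => P (CX j k))); [intros; eapply Hm; eauto|intro; apply H]. }
  pose proof (Rmin_l d1 (Rmin d2 d3)). pose proof (Rmin_r d1 (Rmin d2 d3)).
  pose proof (Rmin_l d2 d3). pose proof (Rmin_r d2 d3).
  assert (0 < Rmin d1 (Rmin d2 d3)) by (repeat apply Rmin_pos; auto).
  exists (Rmin d1 (Rmin d2 d3)). split; auto.
  intros [e|j|j k]; [apply (Hm _ d1)|apply (Hm _ d2)|apply (Hm _ d3)]; auto; lra.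
Qed.

Lemma xclose_iff_coords d (x y : state Nw) : xclose d x y <-> forall c, Rabs (coord_val x c - coord_val y c) < d.
Proof.
  split.
  - intros [H1 [H2 H3]] [e|j|j k]; simpl; auto.
  - intro H. split; [|split]; intros; [apply (H (CE _))|apply (H (CO _))|apply (H (CX _ _))].
Qed.

Lemma xclose_weaken d d' (x y : state Nw) : d <= d' -> xclose d x y -> xclose d' x y.
Proof. rewrite !xclose_iff_coords. intros H H1 c. specialize (H1 c). lra. Qed.

Lemma xclose_sym d (x y : state Nw) : xclose d x y -> xclose d y x.
Proof. rewrite !xclose_iff_coords. intros H c. rewrite Rabs_minus_sym. auto. Qed.

Lemma xclose_vnorm_xs d (x y : state Nw) j : xclose d x y -> vnorm (vsub (xs x j) (xs y j)) <= INR (nd Nw j) * d.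
Proof. intros [_ [_ H]]. apply vnorm_le_coord_bound. intro k. left. apply H. Qed.

Lemma xclose_node_input d (x y : state Nw) j : xclose d x y ->
  vnorm (vsub (xs x j) (xs y j)) + Rabs (- om x j - - om y j) <= (INR (nd Nw j) + 1) * d.
Proof.
  intro Hxy. pose proof (xclose_vnorm_xs d x y j Hxy). destruct Hxy as [_ [Hw _]]. specialize (Hw j).
  replace (- om x j - - om y j) with (- (om x j - om y j)) by ring. rewrite Rabs_Ropp. lra.
Qed.

Lemma Un_cv_xclose (y : nat -> state Nw) (p : state Nw) :
  (forall c, Un_cv (fun n => coord_val (y n) c) (coord_val p c)) ->
  forall eps, 0 < eps -> exists N : nat, forall n, (N <= n)%nat -> xclose eps (y n) p.
Proof.
  intros Hc eps He.
  destruct (coord_common_radius (fun c d => forall n, / d <= INR n -> Rabs (coord_val (y n) c - coord_val p c) < eps))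
    as [d [Hd H]].
  - intros c d d' Hd' Hp n Hn. apply Hp. eapply Rle_trans; [|apply Hn]. apply Rinv_le_contravar; lra.
  - intro c. destruct (Hc c eps He) as [N HN]. exists (/ (INR N + 1)).
    split; [apply Rinv_0_lt_compat; pose proof (pos_INR N); lra|].
    intros n Hn. rewrite Rinv_inv in Hn. apply HN, INR_le. lra.
  - destruct (INR_unbounded (/ d)) as [N HN]. exists N. intros n Hn. apply xclose_iff_coords. intro c. apply H.
    apply le_INR in Hn. lra.
Qed.

Definition out_flow (x : state Nw) j := edge_sum_at (src Nw) (pflow x) j.
Definition in_flow (x : state Nw) j := edge_sum_at (dst Nw) (pflow x) j.

(* The frequency equation with sigma = 0, the only load state met near x*. *)
Definition om_rhs (x : state Nw) j :=
  (- pL Nw j + gs Nw j (xs x j) (- om x j) - out_flow x j + in_flow x j) / Mc Nw j.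

Lemma flow_om_sg0 (z : hstate Nw) j : (forall j, sg z j = 0%Z) -> flow_om z j = om_rhs (hx z) j.
Proof. intro H. unfold flow_om, om_rhs, out_flow, in_flow, edge_sum_at. rewrite H. simpl IZR. f_equal. ring. Qed.

Definition coord_rhs (x : state Nw) (c : coord) : R :=
  match c with
  | CE e => om x (src Nw e) - om x (dst Nw e)
  | CO j => om_rhs x j
  | CX j k => fs Nw j (xs x j) (- om x j) k
  end.

(* Summation by parts over the incidence structure. *)
Lemma flow_power_identity (x y : state Nw) :
  fsum (nN Nw) (fun j => om x j * (- (out_flow x j - out_flow y j) + (in_flow x j - in_flow y j))) =
  fsum (nE Nw) (fun e => (pflow x e - pflow y e) * (om x (dst Nw e) - om x (src Nw e))).
Proof.
  unfold out_flow, in_flow. rewrite (fsum_ext _ _ (fun j =>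
     - (om x j * edge_sum_at (src Nw) (fun e => pflow x e - pflow y e) j) +
     om x j * edge_sum_at (dst Nw) (fun e => pflow x e - pflow y e) j))
    by (intro j; rewrite !edge_sum_at_minus; ring).
  rewrite fsum_plus, fsum_opp. unfold edge_sum_at. rewrite !fsum_incidence, <- fsum_opp, <- fsum_plus.
  apply fsum_ext. intro; ring.
Qed.

Hypothesis HM : forall j, 0 < Mc Nw j.
Hypothesis HB : forall e, 0 < Bc Nw e.
Hypothesis Hlip : forall j, globally_lipschitz (fs Nw j) (gs Nw j).

Lemma edge_flow_lipschitz d (x y : state Nw) j : xclose d x y ->
  Rabs (out_flow x j - out_flow y j) <= fsum (nE Nw) (Bc Nw) * d /\
  Rabs (in_flow x j - in_flow y j) <= fsum (nE Nw) (Bc Nw) * d.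
Proof.
  intros [Hxy _].
  assert (Hp : forall e, Rabs (pflow x e - pflow y e) <= Bc Nw e * d).
  { intro e. unfold pflow. rewrite <- Rmult_minus_distr_l, Rabs_mult, Rabs_right by (left; apply HB).
    apply Rmult_le_compat_l; [left; apply HB|]. eapply Rle_trans; [apply Rabs_sin_sub_le|]. left; apply Hxy. }
  rewrite Rmult_comm, <- fsum_scal. unfold out_flow, in_flow. rewrite !edge_sum_at_minus.
  split; apply Rabs_edge_sum_at_le; intro e; rewrite Rmult_comm; apply Hp.
Qed.

Lemma coord_rhs_lipschitz c : exists Lc, 0 <= Lc /\
  forall x y d, 0 <= d -> xclose d x y -> Rabs (coord_rhs x c - coord_rhs y c) <= Lc * d.
Proof.
  destruct c as [e|j|j k].
  - exists 2. split; [lra|]. intros x y d Hd [_ [H _]]. simpl.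
    replace (om x (src Nw e) - om x (dst Nw e) - (om y (src Nw e) - om y (dst Nw e))) with
      ((om x (src Nw e) - om y (src Nw e)) - (om x (dst Nw e) - om y (dst Nw e))) by ring.
    eapply Rle_trans; [apply Rabs_triang|]. rewrite Rabs_Ropp.
    specialize (H (src Nw e)) as H1. specialize (H (dst Nw e)). lra.
  - destruct (lipschitz_pos _ _ (Hlip j)) as [L [HL HL']]. set (SB := fsum (nE Nw) (Bc Nw)).
    assert (HSB : 0 <= SB) by (apply fsum_nonneg; intro; left; apply HB).
    pose proof (pos_INR (nd Nw j)). specialize (HM j).
    exists ((L * (INR (nd Nw j) + 1) + 2 * SB) / Mc Nw j).
    split; [apply Rmult_le_pos; [nra|left; apply Rinv_0_lt_compat; auto]|].
    intros x y d Hd Hxy. simpl. unfold om_rhs.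
    destruct (edge_flow_lipschitz d x y j Hxy) as [Ho Hi].
    destruct (HL' (xs x j) (xs y j) (- om x j) (- om y j)) as [_ Hg].
    pose proof (xclose_node_input d x y j Hxy).
    set (a1 := gs Nw j (xs x j) (- om x j) - gs Nw j (xs y j) (- om y j)) in *.
    set (a2 := out_flow x j - out_flow y j) in *. set (a3 := in_flow x j - in_flow y j) in *.
    replace ((- pL Nw j + gs Nw j (xs x j) (- om x j) - out_flow x j + in_flow x j) / Mc Nw j -
             (- pL Nw j + gs Nw j (xs y j) (- om y j) - out_flow y j + in_flow y j) / Mc Nw j) with
      ((a1 - a2 + a3) / Mc Nw j) by (unfold a1, a2, a3; field; lra).
    unfold Rdiv. rewrite Rabs_mult, (Rabs_right (/ Mc Nw j)) by (left; apply Rinv_0_lt_compat; auto).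
    replace ((L * (INR (nd Nw j) + 1) + 2 * SB) * / Mc Nw j * d) with
      ((L * ((INR (nd Nw j) + 1) * d) + 2 * SB * d) * / Mc Nw j) by ring.
    apply Rmult_le_compat_r; [left; apply Rinv_0_lt_compat; auto|].
    pose proof (Rabs_triang (a1 - a2) a3). pose proof (Rabs_triang a1 (- a2)). rewrite Rabs_Ropp in *.
    assert (L * (vnorm (vsub (xs x j) (xs y j)) + Rabs (- om x j - - om y j)) <= L * ((INR (nd Nw j) + 1) * d))
      by (apply Rmult_le_compat_l; lra).
    unfold SB, Rminus in *. lra.
  - destruct (lipschitz_pos _ _ (Hlip j)) as [L [HL HL']]. pose proof (pos_INR (nd Nw j)).
    exists (L * (INR (nd Nw j) + 1)). split; [nra|]. intros x y d Hd Hxy. simpl.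
    destruct (HL' (xs x j) (xs y j) (- om x j) (- om y j)) as [Hf _].
    pose proof (Rabs_coord_le_vnorm _ (vsub (fs Nw j (xs x j) (- om x j)) (fs Nw j (xs y j) (- om y j))) k).
    pose proof (xclose_node_input d x y j Hxy).
    assert (L * (vnorm (vsub (xs x j) (xs y j)) + Rabs (- om x j - - om y j)) <= L * ((INR (nd Nw j) + 1) * d))
      by (apply Rmult_le_compat_l; lra).
    unfold vsub in *. lra.
Qed.

End Network.
Arguments CE {Nw}. Arguments CO {Nw}. Arguments CX {Nw}.

(** * The energy *)

(* Bregman divergence of -cos: the potential energy stored in a line, up to the factor B. *)
Definition cos_bregman a b := cos b - cos a - sin b * (a - b).

Lemma derivable_pt_lim_half_sq C f t d :
  derivable_pt_lim f t d -> derivable_pt_lim (fun s => C * (f s * f s) / 2) t (C * f t * d).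
Proof.
  intro H. eapply derivable_pt_lim_eq_ext; [| |apply (derivable_pt_lim_cmul (C/2) _ t _ (derivable_pt_lim_mult f f t d d H H))].
  - intro s. unfold mult_fct. field.
  - field.
Qed.

Lemma derivable_pt_lim_cos_bregman B f t d b : derivable_pt_lim f t d ->
  derivable_pt_lim (fun s => B * cos_bregman (f s) b) t (B * (sin (f t) - sin b) * d).
Proof.
  intro H. unfold cos_bregman.
  assert (H1 : derivable_pt_lim (fun s => cos (f s)) t (- sin (f t) * d))
    by (apply (derivable_pt_lim_comp f cos); auto; apply derivable_pt_lim_cos).
  assert (H2 : derivable_pt_lim (fun s => cos b - cos (f s) - sin b * (f s - b)) t
                 (0 - (- sin (f t) * d) - sin b * (d - 0))).
  { apply derivable_pt_lim_minus; [apply derivable_pt_lim_minus; [apply derivable_pt_lim_const|auto]|].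
    apply derivable_pt_lim_cmul, derivable_pt_lim_minus; [auto|apply derivable_pt_lim_const]. }
  eapply derivable_pt_lim_eq_ext; [| |apply (derivable_pt_lim_cmul B _ _ _ H2)]; [intro; reflexivity|ring].
Qed.

Lemma cos_bregman_deriv a b : derivable_pt_lim (fun s => cos_bregman s b) a (sin a - sin b).
Proof.
  eapply derivable_pt_lim_eq_ext;
    [| |apply (derivable_pt_lim_cos_bregman 1 (fun s => s) a 1 b (derivable_pt_lim_id a))]; simpl; [intro|]; ring.
Qed.

Lemma cos_bregman_nonneg a b : Rabs a <= PI/2 -> Rabs b <= PI/2 -> 0 <= cos_bregman a b.
Proof.
  intros Ha Hb. apply Rabs_le_inv in Ha. apply Rabs_le_inv in Hb.
  assert (hbb : cos_bregman b b = 0) by (unfold cos_bregman; ring).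
  destruct (Rle_dec b a).
  - assert (0 * (a - b) <= cos_bregman a b - cos_bregman b b); [|lra].
    apply (mean_value_ge (fun s => cos_bregman s b)); auto. intros t Ht. exists (sin t - sin b).
    split; [apply cos_bregman_deriv|]. assert (sin b <= sin t) by (apply sin_incr_1; lra). lra.
  - assert (cos_bregman b b - cos_bregman a b <= 0 * (b - a)); [|lra].
    apply (mean_value_le (fun s => cos_bregman s b)); [lra|]. intros t Ht. exists (sin t - sin b).
    split; [apply cos_bregman_deriv|]. assert (sin t <= sin b) by (apply sin_incr_1; lra). lra.
Qed.

Lemma cos_bregman_pos a b r : 0 < r -> Rabs b + r < PI/2 -> Rabs (a - b) = r -> 0 < cos_bregman a b.
Proof.
  intros Hr Hb Hab. pose proof (Rabs_pos b). pose proof (Rle_abs b). pose proof (Rle_abs (-b)). rewrite Rabs_Ropp in *.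
  destruct (Rle_dec b a).
  - rewrite Rabs_right in Hab by lra.
    assert (0 <= cos_bregman (b + r/2) b) by (apply cos_bregman_nonneg; apply Rabs_le; lra).
    assert ((sin (b + r/2) - sin b) * (a - (b + r/2)) <= cos_bregman a b - cos_bregman (b + r/2) b).
    { apply (mean_value_ge (fun s => cos_bregman s b)); [lra|]. intros t Ht. exists (sin t - sin b).
      split; [apply cos_bregman_deriv|]. assert (sin (b + r/2) <= sin t) by (apply sin_incr_1; lra). lra. }
    assert (sin b < sin (b + r/2)) by (apply sin_increasing_1; lra).
    assert (0 < (sin (b + r/2) - sin b) * (a - (b + r/2))) by (apply Rmult_lt_0_compat; lra). lra.
  - rewrite Rabs_left in Hab by lra.
    assert (0 <= cos_bregman (b - r/2) b) by (apply cos_bregman_nonneg; apply Rabs_le; lra).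
    assert (cos_bregman (b - r/2) b - cos_bregman a b <= (sin (b - r/2) - sin b) * ((b - r/2) - a)).
    { apply (mean_value_le (fun s => cos_bregman s b)); [lra|]. intros t Ht. exists (sin t - sin b).
      split; [apply cos_bregman_deriv|]. assert (sin t <= sin (b - r/2)) by (apply sin_incr_1; lra). lra. }
    assert (sin (b - r/2) < sin b) by (apply sin_increasing_1; lra).
    assert ((sin (b - r/2) - sin b) * ((b - r/2) - a) < 0) by (apply Rmult_neg_pos; lra). lra.
Qed.

Section Energy.
Variable Nw : Net.
Variable xst : state Nw.
Variable V : forall j, Vec (nd Nw j) -> R.
Variable G : forall j, Vec (nd Nw j) -> Vec (nd Nw j).

Definition energy (x : state Nw) :=
  fsum (nN Nw) (fun j => Mc Nw j * (om x j * om x j) / 2) +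
  fsum (nE Nw) (fun e => Bc Nw e * cos_bregman (eta x e) (eta xst e)) +
  fsum (nN Nw) (fun j => V j (xs x j) - V j (xs xst j)).

Definition energy_rate (x : state Nw) :=
  fsum (nN Nw) (fun j => Mc Nw j * om x j * om_rhs Nw x j) +
  fsum (nE Nw) (fun e => Bc Nw e * (sin (eta x e) - sin (eta xst e)) * (om x (src Nw e) - om x (dst Nw e))) +
  fsum (nN Nw) (fun j => vdot (G j (xs x j)) (fs Nw j (xs x j) (- om x j))).

(* Supply rate minus storage rate at bus j; input strict passivity bounds it from below. *)
Definition passivity_gap j (y : Vec (nd Nw j)) u :=
  u * (gs Nw j y u - gs Nw j (xs xst j) 0) - vdot (G j y) (fs Nw j y u).

Lemma energy_derivative (HC1 : forall j, C1_with_grad (V j) (G j)) (x : R -> state Nw) t :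
  (forall c, derivable_pt_lim (fun s => coord_val Nw (x s) c) t (coord_rhs Nw (x t) c)) ->
  derivable_pt_lim (fun s => energy (x s)) t (energy_rate (x t)).
Proof.
  intro H. unfold energy, energy_rate.
  apply (derivable_pt_lim_plus (fun s => _ + _) (fun s => fsum (nN Nw) (fun j => V j (xs (x s) j) - V j (xs xst j)))).
  apply (derivable_pt_lim_plus (fun s => fsum (nN Nw) (fun j => Mc Nw j * (om (x s) j * om (x s) j) / 2))
           (fun s => fsum (nE Nw) (fun e => Bc Nw e * cos_bregman (eta (x s) e) (eta xst e)))).
  - apply (derivable_pt_lim_fsum _ (fun j s => Mc Nw j * (om (x s) j * om (x s) j) / 2)). intro j.
    apply derivable_pt_lim_half_sq, (H (CO j)).
  - apply (derivable_pt_lim_fsum _ (fun e s => Bc Nw e * cos_bregman (eta (x s) e) (eta xst e))). intro e.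
    apply derivable_pt_lim_cos_bregman, (H (CE e)).
  - apply (derivable_pt_lim_fsum _ (fun j s => V j (xs (x s) j) - V j (xs xst j))). intro j.
    rewrite <- (Rminus_0_r (vdot _ _)).
    apply derivable_pt_lim_minus; [|apply derivable_pt_lim_const].
    apply (C1_chain_rule _ (V j) (G j) (fun s => xs (x s) j)); auto. intro k. apply (H (CX j k)).
Qed.

(* With the power balance at x*, the line terms cancel against the flow imbalance and only the
   bus dissipation remains. *)
Lemma energy_rate_dissipation (HM : forall j, 0 < Mc Nw j)
  (bal : forall j, - pL Nw j + gs Nw j (xs xst j) 0 - out_flow Nw xst j + in_flow Nw xst j = 0) x :
  energy_rate x = - fsum (nN Nw) (fun j => passivity_gap j (xs x j) (- om x j)).
Proof.
  unfold energy_rate.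
  rewrite (fsum_ext _ (fun j => Mc Nw j * om x j * om_rhs Nw x j)
    (fun j => om x j * (gs Nw j (xs x j) (- om x j) - gs Nw j (xs xst j) 0) +
              om x j * (- (out_flow Nw x j - out_flow Nw xst j) + (in_flow Nw x j - in_flow Nw xst j)))).
  2:{ intro j. unfold om_rhs. specialize (bal j). specialize (HM j).
      replace (- pL Nw j + gs Nw j (xs x j) (- om x j) - out_flow Nw x j + in_flow Nw x j) with
        ((gs Nw j (xs x j) (- om x j) - gs Nw j (xs xst j) 0) +
         (- (out_flow Nw x j - out_flow Nw xst j) + (in_flow Nw x j - in_flow Nw xst j))) by lra.
      field. lra. }
  rewrite fsum_plus, flow_power_identity, <- fsum_opp.
  assert (fsum (nE Nw) (fun e => (pflow x e - pflow xst e) * (om x (dst Nw e) - om x (src Nw e))) +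
          fsum (nE Nw) (fun e => Bc Nw e * (sin (eta x e) - sin (eta xst e)) * (om x (src Nw e) - om x (dst Nw e))) = 0)
    by (rewrite <- fsum_plus; apply fsum_zero; intro e; unfold pflow; ring).
  assert (fsum (nN Nw) (fun j => om x j * (gs Nw j (xs x j) (- om x j) - gs Nw j (xs xst j) 0)) +
          fsum (nN Nw) (fun j => vdot (G j (xs x j)) (fs Nw j (xs x j) (- om x j))) =
          fsum (nN Nw) (fun j => - passivity_gap j (xs x j) (- om x j)))
    by (rewrite <- fsum_plus; apply fsum_ext; intro j; unfold passivity_gap; ring).
  lra.
Qed.

End Energy.

(** * Hybrid solutions *)

Lemma hybrid_time_domain_nonneg (K : R -> nat -> Prop) : hybrid_time_domain K -> forall t, K t O -> 0 <= t.
Proof.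
  intros [tt [H0 [Hmono [Hall | [J [k Hk]]]]]] t Ht.
  - apply Hall in Ht. lra.
  - apply Hk in Ht. destruct Ht as [[_ Ht]|[HJ Ht]]; [lra|]. subst J. destruct k; simpl in Ht; lra.
Qed.

Lemma hybrid_time_domain_down_closed (K : R -> nat -> Prop) : hybrid_time_domain K ->
  forall t s, K t O -> 0 <= s <= t -> K s O.
Proof.
  intros [tt [H0 [Hmono [Hall | [J [k Hk]]]]]] t s Ht Hs.
  - apply Hall in Ht. apply Hall. lra.
  - apply Hk in Ht. apply Hk. destruct Ht as [[HJ Ht]|[HJ Ht]]; [left; split; auto; lra|].
    right. split; auto. subst J. destruct k; simpl in *; lra.
Qed.

Lemma hybrid_time_domain_first_jump (K : R -> nat -> Prop) : hybrid_time_domain K ->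
  forall t l, K t l -> l <> O -> exists t1, K t1 O /\ K t1 1%nat.
Proof.
  intros [tt [H0 [Hmono [Hall | [J [k Hk]]]]]] t l Ht Hl.
  - exists (tt 1%nat). pose proof (Hmono O). pose proof (Hmono 1%nat). split; apply Hall; lra.
  - apply Hk in Ht. pose proof (Hmono O). pose proof (Hmono 1%nat).
    assert (HJ : (1 <= J)%nat) by (destruct Ht as [[HJ _]|[HJ _]]; lia).
    exists (tt 1%nat). split; apply Hk; [left; split; [lia|lra]|].
    destruct (Nat.eq_dec J 1) as [E1|E1]; [|left; split; [lia|lra]].
    right. split; auto. subst J. destruct k; simpl; try lra.
    destruct Ht as [[HJ' _]|[HJ' Ht]]; [lia|]. subst l. simpl in Ht. lra.
Qed.

Section Solutions.
Variable Nw : Net.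
Hypothesis HM : forall j, 0 < Mc Nw j.
Hypothesis HB : forall e, 0 < Bc Nw e.
Hypothesis Hlip : forall j, globally_lipschitz (fs Nw j) (gs Nw j).
Variable K : R -> nat -> Prop.
Variable z : R -> nat -> hstate Nw.
Hypothesis Hsol : is_solution K z.

Lemma solution_sg_const t : K t O -> sg (z t O) = sg (z 0 O).
Proof. destruct Hsol as [_ [H0 [_ [Hf _]]]]. destruct (Hf O) as [_ [Hs _]]. intro Ht. apply Hs; auto. Qed.

Lemma solution_abs_cont a b c : K a O -> K b O -> a <= b ->
  abs_cont_on (fun s => coord_val Nw (hx (z s O)) c) a b.
Proof.
  destruct Hsol as [_ [_ [_ [Hf _]]]]. intros Ha Hb Hab. destruct (Hf O) as [Hac _].
  destruct (Hac a b Ha Hb Hab) as [H1 [H2 H3]]. destruct c; simpl; auto.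
Qed.

Lemma solution_continuous t : K t O -> forall eps, 0 < eps -> exists del, 0 < del /\
  forall s, K s O -> Rabs (s - t) < del -> xclose eps (hx (z s O)) (hx (z t O)).
Proof.
  intros Ht eps He. destruct Hsol as [Hd [H0 _]].
  pose proof (hybrid_time_domain_nonneg K Hd) as Dpos.
  assert (Hnear : forall b, K b O -> exists d, 0 < d /\ forall c s u, 0 <= s <= u -> u <= b -> u - s < d ->
            Rabs (coord_val Nw (hx (z u O)) c - coord_val Nw (hx (z s O)) c) < eps).
  { intros b Hb. apply (coord_common_radius Nw (fun c del => forall s u, 0 <= s <= u -> u <= b -> u - s < del ->
        Rabs (coord_val Nw (hx (z u O)) c - coord_val Nw (hx (z s O)) c) < eps)).
    - intros c d d' Hd' Hp s u H1 H2 H3. apply Hp; auto; lra.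
    - intro c. apply (abs_cont_near _ 0 b (solution_abs_cont 0 b c H0 Hb (Dpos b Hb)) eps He). }
  destruct (classic (exists b, K b O /\ t < b)) as [[b [Hb Htb]]|Hnb].
  - destruct (Hnear b Hb) as [d [Hd0 Hd1]].
    pose proof (Rmin_l d (b - t)). pose proof (Rmin_r d (b - t)).
    exists (Rmin d (b - t)). split; [apply Rmin_pos; lra|]. intros s Ks Hst.
    pose proof (Dpos s Ks). pose proof (Dpos t Ht). apply Rabs_def2 in Hst.
    apply xclose_iff_coords. intro c. destruct (Rle_dec s t).
    + rewrite Rabs_minus_sym. apply Hd1; lra.
    + apply Hd1; lra.
  - destruct (Hnear t Ht) as [d [Hd0 Hd1]]. exists d. split; auto. intros s Ks Hst. pose proof (Dpos s Ks).
    assert (s <= t) by (apply Rnot_lt_le; intro; apply Hnb; exists s; auto).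
    apply Rabs_def2 in Hst. apply xclose_iff_coords. intro c. rewrite Rabs_minus_sym. apply Hd1; lra.
Qed.

(* Since the vector field is continuous, the a.e. derivative of the absolutely continuous
   solution is an everywhere derivative. *)
Lemma solution_derivable : (forall j, sg (z 0 O) j = 0%Z) -> forall t b, K b O -> 0 < t < b -> forall c,
  derivable_pt_lim (fun s => coord_val Nw (hx (z s O)) c) t (coord_rhs Nw (hx (z t O)) c).
Proof.
  intros Hsg t b Hb Htb c. pose proof Hsol as [Hd [H0 [_ [Hf _]]]].
  pose proof (hybrid_time_domain_down_closed K Hd) as Ddown.
  destruct (Hf O) as [_ [_ [_ Hnull]]].
  assert (Kt : K t O) by (apply (Ddown b); auto; lra).
  apply (abs_cont_derivable _ (fun s => coord_rhs Nw (hx (z s O)) c) 0 b (fun s => K s O /\ ~ flow_deriv_at z O s));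
    auto.
  - apply solution_abs_cont; auto; lra.
  - intros s Hsb HE. assert (Ks : K s O) by (apply (Ddown b); auto).
    assert (Hfd : flow_deriv_at z O s) by (apply NNPP; intro; apply HE; auto).
    assert (Hsg' : forall j, sg (z s O) j = 0%Z) by (intro j; rewrite solution_sg_const; auto).
    destruct Hfd as [F1 [F2 F3]]. destruct c as [e|j|j k]; simpl; [apply F1| |apply F3].
    rewrite <- flow_om_sg0; auto.
  - intros eps He. destruct (coord_rhs_lipschitz Nw HM HB Hlip c) as [Lc [HLc HLc']].
    destruct (solution_continuous t Kt (eps / (Lc + 1))) as [d [Hd0 Hd1]]; [apply Rdiv_lt_0_compat; lra|].
    exists d. split; auto. intros s Hsb Hst. assert (Ks : K s O) by (apply (Ddown b); auto).
    specialize (HLc' _ _ (eps / (Lc + 1)) ltac:(left; apply Rdiv_lt_0_compat; lra) (Hd1 s Ks Hst)).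
    eapply Rle_lt_trans; [apply HLc'|]. apply Rmult_lt_reg_r with (Lc + 1); [lra|].
    replace (Lc * (eps / (Lc + 1)) * (Lc + 1)) with (Lc * eps) by (field; lra). nra.
Qed.

End Solutions.

(** * Lyapunov analysis near the equilibrium *)

Section Lyapunov.
Variable Nw : Net.
Hypothesis HM : forall j, 0 < Mc Nw j.
Hypothesis HB : forall e, 0 < Bc Nw e.
Hypothesis Hw : forall j, 0 < w0 Nw j < w1 Nw j.
Hypothesis Hlip : forall j, globally_lipschitz (fs Nw j) (gs Nw j).
Variable xst : state Nw.
Hypothesis om_star : forall j, om xst j = 0.
Hypothesis bal : forall j, - pL Nw j + gs Nw j (xs xst j) 0 - out_flow Nw xst j + in_flow Nw xst j = 0.
Variable V : forall j, Vec (nd Nw j) -> R.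
Variable G : forall j, Vec (nd Nw j) -> Vec (nd Nw j).
Variable ph : Fin.t (nN Nw) -> R -> R.
Hypothesis HC1 : forall j, C1_with_grad (V j) (G j).
Hypothesis Hph : forall j, pos_def (ph j).
(* r is small enough that all the local hypotheses hold on the box of radius r around x*, and
   that |omega| < r keeps every load in its off state. *)
Variable r : R.
Hypothesis Hr : 0 < r.
Hypothesis Hr_w0 : forall j, r < w0 Nw j.
(* The literal [u - 0] and [- 0] are those of loc_ISP at input 0 and of (A1)(ii) at frequency 0. *)
Hypothesis Hpass : forall j u y, Rabs u <= r -> vnorm (vsub y (xs xst j)) <= r ->
  vdot (G j y) (fs Nw j y u) <= (u - 0) * (gs Nw j y u - gs Nw j (xs xst j) 0) - ph j (u - 0).
Hypothesis Hmin : forall j, exists d, r < d /\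
  forall y, 0 < vnorm (vsub y (xs xst j)) < d -> V j (xs xst j) < V j y.
Hypothesis Hangle : forall e, Rabs (eta xst e) + r < PI/2.
Hypothesis A1ii : forall j (M : Vec (nd Nw j) -> Prop), vcompact M ->
  invariant_set (fun x => fs Nw j x (- 0)) M -> forall x, M x -> forall k, fs Nw j x (- 0) k = 0.

Definition in_cbox (x : state Nw) :=
  (forall e, Rabs (eta x e - eta xst e) <= r) /\ (forall j, Rabs (om x j) <= r) /\
  (forall j, vnorm (vsub (xs x j) (xs xst j)) <= r).
Definition in_obox (x : state Nw) :=
  (forall e, Rabs (eta x e - eta xst e) < r) /\ (forall j, Rabs (om x j) < r) /\
  (forall j, vnorm (vsub (xs x j) (xs xst j)) < r).

Lemma in_obox_cbox x : in_obox x -> in_cbox x.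
Proof. intros [H1 [H2 H3]]. split; [|split]; intros; left; auto. Qed.

Lemma in_obox_eq : in_obox xst.
Proof.
  split; [|split]; intros.
  - rewrite Rminus_diag, Rabs_R0. auto.
  - rewrite om_star, Rabs_R0. auto.
  - unfold vnorm. rewrite fsum_zero; auto. intro k. unfold vsub. rewrite Rminus_diag, Rabs_R0. auto.
Qed.

Lemma in_cbox_xclose x : in_cbox x -> xclose (r + 1) xst x.
Proof.
  intros [H1 [H2 H3]]. split; [|split].
  - intro e. rewrite Rabs_minus_sym. specialize (H1 e). lra.
  - intro j. rewrite om_star, Rminus_0_l, Rabs_Ropp. specialize (H2 j). lra.
  - intros j k. specialize (H3 j). rewrite Rabs_minus_sym.
    pose proof (Rabs_coord_le_vnorm _ (vsub (xs x j) (xs xst j)) k). unfold vsub in *. lra.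
Qed.

Lemma in_obox_open x : in_obox x -> exists del, 0 < del /\ forall y, xclose del x y -> in_obox y.
Proof.
  intros [H1 [H2 H3]].
  destruct (fin_common_radius _ (fun e d => d <= r - Rabs (eta x e - eta xst e))) as [d1 [Hd1 D1]];
    [intros; lra|intro e; exists (r - Rabs (eta x e - eta xst e)); specialize (H1 e); split; lra|].
  destruct (fin_common_radius _ (fun j d => d <= r - Rabs (om x j))) as [d2 [Hd2 D2]];
    [intros; lra|intro j; exists (r - Rabs (om x j)); specialize (H2 j); split; lra|].
  destruct (fin_common_radius _ (fun j d => (INR (nd Nw j) + 1) * d <= r - vnorm (vsub (xs x j) (xs xst j))))
    as [d3 [Hd3 D3]].
  { intros j d d' Hd' Hp. pose proof (pos_INR (nd Nw j)). nra. }
  { intro j. pose proof (pos_INR (nd Nw j)). specialize (H3 j).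
    exists ((r - vnorm (vsub (xs x j) (xs xst j))) / (INR (nd Nw j) + 1)).
    split; [apply Rdiv_lt_0_compat; lra|]. right; field; lra. }
  pose proof (Rmin_l d1 (Rmin d2 d3)). pose proof (Rmin_r d1 (Rmin d2 d3)).
  pose proof (Rmin_l d2 d3). pose proof (Rmin_r d2 d3).
  exists (Rmin d1 (Rmin d2 d3)). split; [repeat apply Rmin_pos; auto|].
  intros y Hy. split; [|split].
  - intro e. destruct Hy as [Hy _]. specialize (Hy e). specialize (D1 e).
    replace (eta y e - eta xst e) with ((eta y e - eta x e) + (eta x e - eta xst e)) by ring.
    eapply Rle_lt_trans; [apply Rabs_triang|]. rewrite Rabs_minus_sym in Hy. lra.
  - intro j. destruct Hy as [_ [Hy _]]. specialize (Hy j). specialize (D2 j).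
    replace (om y j) with ((om y j - om x j) + om x j) by ring.
    eapply Rle_lt_trans; [apply Rabs_triang|]. rewrite Rabs_minus_sym in Hy. lra.
  - intro j. pose proof (xclose_vnorm_xs Nw _ x y j Hy). specialize (D3 j). specialize (H3 j).
    pose proof (pos_INR (nd Nw j)).
    pose proof (vnorm_vsub_triang _ (xs y j) (xs x j) (xs xst j)). rewrite (vnorm_vsub_sym _ (xs y j) (xs x j)) in *.
    assert (INR (nd Nw j) * Rmin d1 (Rmin d2 d3) <= INR (nd Nw j) * d3) by (apply Rmult_le_compat_l; lra).
    nra.
Qed.

Lemma in_cbox_closed x : (forall eps, 0 < eps -> exists y, in_cbox y /\ xclose eps x y) -> in_cbox x.
Proof.
  intro H. split; [|split].
  - intro e. apply Rnot_lt_le. intro Hlt.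
    destruct (H (Rabs (eta x e - eta xst e) - r) ltac:(lra)) as [y [[Hy _] [Hc _]]].
    specialize (Hy e). specialize (Hc e). pose proof (Rabs_triang (eta x e - eta y e) (eta y e - eta xst e)).
    replace (eta x e - eta y e + (eta y e - eta xst e)) with (eta x e - eta xst e) in * by ring. lra.
  - intro j. apply Rnot_lt_le. intro Hlt.
    destruct (H (Rabs (om x j) - r) ltac:(lra)) as [y [[_ [Hy _]] [_ [Hc _]]]].
    specialize (Hy j). specialize (Hc j). pose proof (Rabs_triang (om x j - om y j) (om y j)).
    replace (om x j - om y j + om y j) with (om x j) in * by ring. lra.
  - intro j. apply Rnot_lt_le. intro Hlt. pose proof (pos_INR (nd Nw j)).
    set (gap := vnorm (vsub (xs x j) (xs xst j)) - r).
    destruct (H (gap / (INR (nd Nw j) + 1))) as [y [[_ [_ Hy]] Hc]]; [apply Rdiv_lt_0_compat; unfold gap; lra|].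
    pose proof (xclose_vnorm_xs Nw _ x y j Hc). specialize (Hy j).
    pose proof (vnorm_vsub_triang _ (xs x j) (xs y j) (xs xst j)).
    assert (INR (nd Nw j) * (gap / (INR (nd Nw j) + 1)) < gap).
    { apply Rmult_lt_reg_r with (INR (nd Nw j) + 1); [lra|].
      replace (INR (nd Nw j) * (gap / (INR (nd Nw j) + 1)) * (INR (nd Nw j) + 1)) with (INR (nd Nw j) * gap)
        by (field; lra). unfold gap. nra. }
    unfold gap in *. lra.
Qed.

Lemma coord_bounded_in_cbox : exists B, forall x, in_cbox x -> forall c, Rabs (coord_val Nw x c) <= B.
Proof.
  destruct (coord_common_radius Nw (fun c d => forall x, in_cbox x -> Rabs (coord_val Nw x c) <= / d))
    as [d [Hd H]]; [| |exists (/ d); auto].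
  - intros c d d' Hd' Hp x Hx. eapply Rle_trans; [apply Hp; auto|]. apply Rinv_le_contravar; lra.
  - intro c. exists (/ (Rabs (coord_val Nw xst c) + r + 2)).
    split; [apply Rinv_0_lt_compat; pose proof (Rabs_pos (coord_val Nw xst c)); lra|].
    intros x Hx. rewrite Rinv_inv. pose proof (in_cbox_xclose x Hx) as H. rewrite xclose_iff_coords in H.
    specialize (H c). pose proof (Rabs_triang_inv (coord_val Nw x c) (coord_val Nw xst c)).
    rewrite Rabs_minus_sym in H. lra.
Qed.

Lemma coord_rhs_bounded_in_cbox : exists Lx, 0 < Lx /\ forall x, in_cbox x -> forall c, Rabs (coord_rhs Nw x c) <= Lx.
Proof.
  destruct (coord_common_radius Nw (fun c d => forall x, in_cbox x -> Rabs (coord_rhs Nw x c) <= / d))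
    as [d [Hd H]]; [| |exists (/ d); split; [apply Rinv_0_lt_compat|]; auto].
  - intros c d d' Hd' Hp x Hx. eapply Rle_trans; [apply Hp; auto|]. apply Rinv_le_contravar; lra.
  - intro c. destruct (coord_rhs_lipschitz Nw HM HB Hlip c) as [Lc [HLc HLc']].
    exists (/ (Rabs (coord_rhs Nw xst c) + Lc * (r + 1) + 1)).
    split; [apply Rinv_0_lt_compat; pose proof (Rabs_pos (coord_rhs Nw xst c)); nra|].
    intros x Hx. rewrite Rinv_inv. specialize (HLc' xst x (r + 1) ltac:(lra) (in_cbox_xclose x Hx)).
    pose proof (Rabs_triang_inv (coord_rhs Nw x c) (coord_rhs Nw xst c)). rewrite Rabs_minus_sym in HLc'. lra.
Qed.

Local Notation E := (energy Nw xst V).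

Lemma storage_term_nonneg j y : vnorm (vsub y (xs xst j)) <= r -> 0 <= V j y - V j (xs xst j).
Proof.
  intro Hy. destruct (Hmin j) as [d [Hd Hd']].
  destruct (Req_dec (vnorm (vsub y (xs xst j))) 0) as [H0|H0].
  - apply vnorm_vsub_eq0 in H0. subst. lra.
  - pose proof (vnorm_nonneg _ (vsub y (xs xst j))). specialize (Hd' y ltac:(lra)). lra.
Qed.

Lemma line_term_nonneg x e : in_cbox x -> 0 <= Bc Nw e * cos_bregman (eta x e) (eta xst e).
Proof.
  intros [H _]. specialize (H e). specialize (Hangle e). pose proof (HB e).
  apply Rmult_le_pos; [lra|]. apply cos_bregman_nonneg; [|lra].
  pose proof (Rabs_triang (eta x e - eta xst e) (eta xst e)).
  replace (eta x e - eta xst e + eta xst e) with (eta x e) in * by ring. lra.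
Qed.

Lemma kinetic_term_nonneg x j : 0 <= Mc Nw j * (om x j * om x j) / 2.
Proof. specialize (HM j). assert (0 <= om x j * om x j) by nra. nra. Qed.

Lemma energy_terms_nonneg x : in_cbox x ->
  0 <= fsum (nN Nw) (fun j => Mc Nw j * (om x j * om x j) / 2) /\
  0 <= fsum (nE Nw) (fun e => Bc Nw e * cos_bregman (eta x e) (eta xst e)) /\
  0 <= fsum (nN Nw) (fun j => V j (xs x j) - V j (xs xst j)).
Proof.
  intro Hx. split; [|split]; apply fsum_nonneg; intro i;
    [apply kinetic_term_nonneg|apply line_term_nonneg; auto|apply storage_term_nonneg, Hx].
Qed.

Lemma energy_nonneg x : in_cbox x -> 0 <= E x.
Proof. intro Hx. destruct (energy_terms_nonneg x Hx) as [A [B C]]. unfold energy. lra. Qed.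

Lemma energy_eq : E xst = 0.
Proof.
  unfold energy. rewrite !fsum_zero; [ring| |  |].
  - intro j. ring.
  - intro e. unfold cos_bregman. ring.
  - intro j. rewrite om_star. field.
Qed.

Lemma ph_nonneg j u : 0 <= ph j u.
Proof. destruct (Hph j) as [H0 H1]. destruct (Req_dec u 0) as [->|]; [lra|left; auto]. Qed.

Lemma passivity_gap_ge x j : in_cbox x -> ph j (- om x j) <= passivity_gap Nw xst G j (xs x j) (- om x j).
Proof.
  intros [_ [H2 H3]]. unfold passivity_gap. specialize (Hpass j (- om x j) (xs x j)).
  rewrite Rabs_Ropp, Rminus_0_r in Hpass. specialize (Hpass (H2 j) (H3 j)). lra.
Qed.

Lemma energy_rate_nonpos x : in_cbox x -> energy_rate Nw xst G x <= 0.
Proof.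
  intro Hx. rewrite energy_rate_dissipation by auto.
  enough (0 <= fsum (nN Nw) (fun j => passivity_gap Nw xst G j (xs x j) (- om x j))) by lra.
  apply fsum_nonneg. intro j. pose proof (passivity_gap_ge x j Hx). pose proof (ph_nonneg j (- om x j)). lra.
Qed.

Lemma cbox_boundary_cases x : in_cbox x -> ~ in_obox x ->
  (exists e, Rabs (eta x e - eta xst e) = r) \/ (exists j, Rabs (om x j) = r) \/
  (exists j, vnorm (vsub (xs x j) (xs xst j)) = r).
Proof.
  intros [Hx1 [Hx2 Hx3]] Hno. apply NNPP. intro Hn. apply Hno. split; [|split].
  - intro e. destruct (Hx1 e); auto. exfalso. apply Hn. left. exists e; auto.
  - intro j. destruct (Hx2 j); auto. exfalso. apply Hn. right. left. exists j; auto.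
  - intro j. destruct (Hx3 j); auto. exfalso. apply Hn. right. right. exists j; auto.
Qed.

Lemma energy_boundary_gap : exists m, 0 < m /\ forall x, in_cbox x -> ~ in_obox x -> m <= E x.
Proof.
  destruct (fin_common_radius _ (fun e m => forall a, Rabs (a - eta xst e) = r -> m <= Bc Nw e * cos_bregman a (eta xst e)))
    as [m1 [Hm1 H1]].
  { intros e d d' Hd H a Ha. specialize (H a Ha). lra. }
  { intro e. pose proof (HB e).
    assert (Hp : forall a, Rabs (a - eta xst e) = r -> 0 < Bc Nw e * cos_bregman a (eta xst e))
      by (intros a Ha; apply Rmult_lt_0_compat; auto; apply (cos_bregman_pos _ _ r); auto).
    set (p1 := Bc Nw e * cos_bregman (eta xst e + r) (eta xst e)).
    set (p2 := Bc Nw e * cos_bregman (eta xst e - r) (eta xst e)).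
    assert (0 < p1) by (apply Hp; replace (eta xst e + r - eta xst e) with r by ring; apply Rabs_right; lra).
    assert (0 < p2) by (apply Hp; replace (eta xst e - r - eta xst e) with (- r) by ring; rewrite Rabs_Ropp; apply Rabs_right; lra).
    exists (Rmin p1 p2). split; [apply Rmin_pos; auto|]. intros a Ha.
    destruct (Rle_dec (eta xst e) a).
    - rewrite Rabs_right in Ha by lra. replace a with (eta xst e + r) by lra. apply Rmin_l.
    - rewrite Rabs_left in Ha by lra. replace a with (eta xst e - r) by lra. apply Rmin_r. }
  destruct (fin_common_radius _ (fun j m => m <= Mc Nw j * (r * r) / 2)) as [m2 [Hm2 H2]];
    [intros; lra|intro j; exists (Mc Nw j * (r * r) / 2); specialize (HM j); assert (0 < r * r) by nra; split; [nra|lra]|].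
  destruct (fin_common_radius _ (fun j m => forall y, vnorm (vsub y (xs xst j)) = r -> m <= V j y - V j (xs xst j)))
    as [m3 [Hm3 H3]].
  { intros j d d' Hd A y Hy. specialize (A y Hy). lra. }
  { intro j. destruct (Hmin j) as [d [Hd Hd']]. apply (C1_strict_min_sphere_gap _ (V j) (G j) (xs xst j) r d); auto. }
  pose proof (Rmin_l m1 (Rmin m2 m3)). pose proof (Rmin_r m1 (Rmin m2 m3)).
  pose proof (Rmin_l m2 m3). pose proof (Rmin_r m2 m3).
  exists (Rmin m1 (Rmin m2 m3)). split; [repeat apply Rmin_pos; auto|].
  intros x Hx Hno. destruct (energy_terms_nonneg x Hx) as [P1 [P2 P3]]. unfold energy.
  destruct (cbox_boundary_cases x Hx Hno) as [[e He]|[[j Hj]|[j Hj]]].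
  - pose proof (fsum_ge_term _ (fun e => Bc Nw e * cos_bregman (eta x e) (eta xst e)) e (fun e => line_term_nonneg x e Hx)).
    specialize (H1 e _ He). lra.
  - pose proof (fsum_ge_term _ (fun j => Mc Nw j * (om x j * om x j) / 2) j (kinetic_term_nonneg x)).
    assert (Hsq : om x j * om x j = r * r) by (rewrite <- Hj; unfold Rabs; destruct (Rcase_abs (om x j)); ring).
    simpl in *. rewrite Hsq in *. specialize (H2 j). lra.
  - pose proof (fsum_ge_term _ (fun j => V j (xs x j) - V j (xs xst j)) j
                  (fun i => storage_term_nonneg i _ (proj2 (proj2 Hx) i))).
    specialize (H3 j _ Hj). lra.
Qed.

Lemma energy_continuous x eps : 0 < eps -> exists del, 0 < del /\ forall y, xclose del x y -> Rabs (E y - E x) < eps.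
Proof.
  intro He.
  assert (Hm : forall d d' (y : state Nw), 0 < d' <= d -> xclose d' x y -> xclose d x y)
    by (intros d d' y Hd H; eapply xclose_weaken; [|apply H]; lra).
  destruct (fsum_near _ (fun j y => Mc Nw j * (om y j * om y j) / 2) (fun d y => xclose d x y) x Hm)
    with (eps := eps/4) as [d1 [Hd1 H1]]; [|lra|].
  { intros j e0 He0.
    destruct (derivable_pt_lim_near _ _ _ (derivable_pt_lim_half_sq (Mc Nw j) (fun v => v) (om x j) 1
                (derivable_pt_lim_id _)) e0 He0) as [d [Hd H]].
    exists d. split; auto. intros y [_ [Hy _]]. apply H. rewrite Rabs_minus_sym. apply Hy. }
  destruct (fsum_near _ (fun e y => Bc Nw e * cos_bregman (eta y e) (eta xst e)) (fun d y => xclose d x y) x Hm)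
    with (eps := eps/4) as [d2 [Hd2 H2]]; [|lra|].
  { intros e e0 He0.
    destruct (derivable_pt_lim_near _ _ _ (derivable_pt_lim_cos_bregman (Bc Nw e) (fun v => v) (eta x e) 1
                (eta xst e) (derivable_pt_lim_id _)) e0 He0) as [d [Hd H]].
    exists d. split; auto. intros y [Hy _]. apply H. rewrite Rabs_minus_sym. apply Hy. }
  destruct (fsum_near _ (fun j y => V j (xs y j) - V j (xs xst j)) (fun d y => xclose d x y) x Hm)
    with (eps := eps/4) as [d3 [Hd3 H3]]; [|lra|].
  { intros j e0 He0. destruct (C1_continuous _ (V j) (G j) (HC1 j) (xs x j) e0 He0) as [d [Hd H]].
    pose proof (pos_INR (nd Nw j)).
    exists (d / (INR (nd Nw j) + 1)). split; [apply Rdiv_lt_0_compat; lra|]. intros y Hy.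
    replace (V j (xs y j) - V j (xs xst j) - (V j (xs x j) - V j (xs xst j))) with (V j (xs y j) - V j (xs x j)) by ring.
    apply H. rewrite vnorm_vsub_sym. eapply Rle_lt_trans; [apply (xclose_vnorm_xs Nw _ x y j Hy)|].
    apply Rmult_lt_reg_r with (INR (nd Nw j) + 1); [lra|].
    replace (INR (nd Nw j) * (d / (INR (nd Nw j) + 1)) * (INR (nd Nw j) + 1)) with (INR (nd Nw j) * d) by (field; lra).
    nra. }
  pose proof (Rmin_l d1 (Rmin d2 d3)). pose proof (Rmin_r d1 (Rmin d2 d3)).
  pose proof (Rmin_l d2 d3). pose proof (Rmin_r d2 d3).
  assert (Hdm : 0 < Rmin d1 (Rmin d2 d3)) by (repeat apply Rmin_pos; auto).
  set (dm := Rmin d1 (Rmin d2 d3)) in *.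
  exists dm. split; auto. intros y Hy.
  specialize (H1 y (Hm d1 dm y ltac:(lra) Hy)). specialize (H2 y (Hm d2 dm y ltac:(lra) Hy)).
  specialize (H3 y (Hm d3 dm y ltac:(lra) Hy)). simpl in H1, H2, H3.
  unfold energy.
  match goal with |- Rabs (?a1 + ?a2 + ?a3 - (?b1 + ?b2 + ?b3)) < _ =>
    replace (a1 + a2 + a3 - (b1 + b2 + b3)) with ((a1 - b1) + (a2 - b2) + (a3 - b3)) by ring;
    pose proof (Rabs_triang (a1 - b1) (a2 - b2)); pose proof (Rabs_triang ((a1 - b1) + (a2 - b2)) (a3 - b3)) end.
  lra.
Qed.

Lemma passivity_gap_lower_bound e : 0 < e -> exists mm, 0 < mm /\ forall j y u,
  vnorm (vsub y (xs xst j)) <= r -> e <= Rabs u <= r -> mm <= passivity_gap Nw xst G j y u.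
Proof.
  intro He.
  apply (fin_common_radius _ (fun j mm => forall y u, vnorm (vsub y (xs xst j)) <= r -> e <= Rabs u <= r ->
            mm <= passivity_gap Nw xst G j y u)).
  { intros j d d' Hd Hp y u Hy Hu. specialize (Hp y u Hy Hu). lra. }
  intro j.
  destruct (continuous_pos_lower_bound _ (passivity_gap Nw xst G j) (xs xst j) 0 r e r) as [mm [Hmm H]].
  - apply (jointly_continuous_minus _ (fun y u => u * (gs Nw j y u - gs Nw j (xs xst j) 0))
             (fun y u => vdot (G j y) (fs Nw j y u))).
    + apply (supply_rate_continuous _ _ (fs Nw j)), Hlip.
    + apply (storage_rate_continuous _ (gs Nw j)); [apply Hlip|apply HC1].
  - intros y u [_ Hy] Hu. unfold passivity_gap. specialize (Hpass j u y ltac:(lra) Hy).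
    rewrite !Rminus_0_r in Hpass. destruct (Hph j) as [_ Hp].
    assert (u <> 0) by (intro; subst; rewrite Rabs_R0 in Hu; lra). specialize (Hp u H). lra.
  - exists mm. split; auto. intros y u Hy Hu. apply H; auto. split; auto. apply vnorm_nonneg.
Qed.

Section Trajectory.
Variable m : R.
Hypothesis Hbd : forall x, in_cbox x -> ~ in_obox x -> m <= E x.
Variable K : R -> nat -> Prop.
Variable z : R -> nat -> hstate Nw.
Hypothesis Hsol : is_solution K z.
Hypothesis HS0 : in_obox (hx (z 0 O)) /\ E (hx (z 0 O)) < m.
Hypothesis HI0 : forall j, inI (w0 Nw j) (w1 Nw j) (om (hx (z 0 O)) j) (sg (z 0 O) j).

Local Notation xt t := (hx (z t O)).

Lemma dom_nonneg t : K t O -> 0 <= t.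
Proof. apply hybrid_time_domain_nonneg, Hsol. Qed.

Lemma dom_down t s : K t O -> 0 <= s <= t -> K s O.
Proof. apply hybrid_time_domain_down_closed, Hsol. Qed.

Lemma sg_initial_zero j : sg (z 0 O) j = 0%Z.
Proof.
  destruct HS0 as [[_ [H2 _]] _]. specialize (H2 j). specialize (Hr_w0 j). specialize (Hw j).
  destruct (HI0 j) as [[A B]|[[A B]|[A B]]]; auto; lra.
Qed.

Lemma sg_zero t : K t O -> forall j, sg (z t O) j = 0%Z.
Proof. intros Ht j. rewrite (solution_sg_const Nw K z Hsol t Ht). apply sg_initial_zero. Qed.

Lemma traj_derivable t b : K b O -> 0 < t < b -> forall c,
  derivable_pt_lim (fun s => coord_val Nw (xt s) c) t (coord_rhs Nw (xt t) c).
Proof. apply (solution_derivable Nw HM HB Hlip K z Hsol sg_initial_zero). Qed.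

Lemma traj_left_approx c : K c O -> 0 < c -> forall d, 0 < d -> exists s, 0 <= s < c /\ xclose d (xt s) (xt c).
Proof.
  intros Kc Hc d Hd. destruct (solution_continuous Nw K z Hsol c Kc d Hd) as [e [He H]].
  pose proof (Rmax_l 0 (c - e/2)). pose proof (Rmax_r 0 (c - e/2)).
  set (s := Rmax 0 (c - e/2)) in *. assert (s < c) by (apply Rmax_lub_lt; lra).
  exists s. split; [lra|]. apply H; [apply (dom_down c); auto; lra|]. apply Rabs_def1; lra.
Qed.

Let W0 := E (xt 0).

(* Up to a slack eps * (s + 1), the trajectory stays in the open box with energy at most W0. *)
Let trap_inv eps s := in_obox (xt s) /\ E (xt s) <= W0 + eps * (s + 1).

Lemma trap_step_right eps t c : 0 < eps -> K t O -> 0 <= c < t -> trap_inv eps c ->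
  exists del, 0 < del /\ forall s, c < s < c + del -> s <= t -> trap_inv eps s.
Proof.
  intros He Ht Hc [Qc1 Qc2]. assert (Kc : K c O) by (apply (dom_down t); auto; lra).
  destruct (in_obox_open _ Qc1) as [d1 [Hd1 Hd1']].
  destruct (solution_continuous Nw K z Hsol c Kc d1 Hd1) as [e1 [He1 He1']].
  assert (HW : exists e2, 0 < e2 /\ forall s, c < s < c + e2 -> s <= t -> E (xt s) <= W0 + eps * (s + 1)).
  { destruct (Req_dec c 0) as [->|Hc0].
    - destruct (energy_continuous (xt 0) eps He) as [d2 [Hd2 Hd2']].
      destruct (solution_continuous Nw K z Hsol 0 (proj1 (proj2 Hsol)) d2 Hd2) as [e2 [He2 He2']].
      exists e2. split; auto. intros s Hs Hst. assert (Ks : K s O) by (apply (dom_down t); auto; lra).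
      specialize (He2' s Ks ltac:(rewrite Rabs_right; lra)). apply xclose_sym in He2'.
      specialize (Hd2' _ He2'). apply Rabs_def2 in Hd2'. unfold W0. assert (0 <= eps * s) by (apply Rmult_le_pos; lra).
      lra.
    - assert (Hder : derivable_pt_lim (fun s => E (xt s)) c (energy_rate Nw xst G (xt c)))
        by (apply energy_derivative; auto; intro cc; apply (traj_derivable c t Ht); lra).
      destruct (derivable_pt_lim_right_le _ c _ eps Hder He) as [e2 [He2 He2']].
      exists e2. split; auto. intros s Hs Hst. specialize (He2' s Hs).
      pose proof (energy_rate_nonpos (xt c) (in_obox_cbox _ Qc1)).
      pose proof (Rmult_le_compat_r (s - c) (energy_rate Nw xst G (xt c) + eps) eps ltac:(lra) ltac:(lra)). nra. }
  destruct HW as [e2 [He2 He2']].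
  pose proof (Rmin_l e1 e2). pose proof (Rmin_r e1 e2).
  exists (Rmin e1 e2). split; [apply Rmin_pos; auto|]. intros s Hs Hst.
  assert (Ks : K s O) by (apply (dom_down t); auto; lra).
  split; [|apply He2'; auto; lra]. apply Hd1', xclose_sym, He1'; auto. rewrite Rabs_right; lra.
Qed.

(* The energy bound passes to the limit by continuity, which keeps the state in the closed box;
   reaching its boundary would cost at least m > W0 + eps * (t + 1). *)
Lemma trap_step_closed eps t c : 0 < eps -> eps * (t + 1) < m - W0 -> K t O -> 0 < c <= t ->
  (forall s, 0 <= s < c -> trap_inv eps s) -> trap_inv eps c.
Proof.
  intros He Hegap Ht Hc HQ. assert (Kc : K c O) by (apply (dom_down t); auto; lra).
  assert (HWc : E (xt c) <= W0 + eps * (c + 1)).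
  { apply Rnot_lt_le. intro Hlt. set (gc := E (xt c) - (W0 + eps * (c + 1))).
    destruct (energy_continuous (xt c) gc ltac:(unfold gc; lra)) as [d [Hd Hd']].
    destruct (traj_left_approx c Kc ltac:(lra) d Hd) as [s [Hs Hsc]].
    specialize (Hd' _ (xclose_sym _ _ _ _ Hsc)). apply Rabs_def2 in Hd'. destruct (HQ s Hs) as [_ HEs].
    pose proof (Rmult_le_compat_l eps (s + 1) (c + 1) ltac:(lra) ltac:(lra)). unfold gc in *. lra. }
  assert (HRc : in_cbox (xt c)).
  { apply in_cbox_closed. intros e' He'. destruct (traj_left_approx c Kc ltac:(lra) e' He') as [s [Hs Hsc]].
    exists (xt s). split; [apply in_obox_cbox, (HQ s Hs)|apply xclose_sym; auto]. }
  split; auto. apply NNPP. intro Hno. specialize (Hbd _ HRc Hno).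
  pose proof (Rmult_le_compat_l eps (c + 1) (t + 1) ltac:(lra) ltac:(lra)). lra.
Qed.

Lemma trap_inv_holds eps t : 0 < eps -> eps * (t + 1) < m - W0 -> K t O ->
  forall s, 0 <= s <= t -> trap_inv eps s.
Proof.
  intros He Hegap Ht. apply (real_induction 0 t (trap_inv eps) (dom_nonneg t Ht)).
  - split; [apply HS0|unfold W0; lra].
  - intros c Hc Qc. apply (trap_step_right eps t c); auto.
  - intros c Hc HQ. apply (trap_step_closed eps t c); auto.
Qed.

Lemma trap t : K t O -> in_obox (xt t) /\ E (xt t) <= E (xt 0).
Proof.
  intro Ht. pose proof (dom_nonneg t Ht). set (gap := m - W0).
  assert (Hgap : 0 < gap) by (unfold gap, W0; destruct HS0; lra).
  assert (Heps : forall d, 0 < d -> d <= gap -> 0 < d / (2 * (t + 1)) /\ d / (2 * (t + 1)) * (t + 1) < gap /\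
                   d / (2 * (t + 1)) * (t + 1) = d / 2)
    by (intros d Hd Hdg; repeat split; [apply Rdiv_lt_0_compat| |field]; try lra;
        replace (d / (2 * (t + 1)) * (t + 1)) with (d / 2) by (field; lra); lra).
  split.
  - destruct (Heps gap Hgap ltac:(lra)) as [Hd1 [Hd2 _]]. apply (trap_inv_holds _ t Hd1 Hd2 Ht). lra.
  - apply Rnot_lt_le. intro Hlt. set (dd := Rmin gap (E (xt t) - W0)).
    pose proof (Rmin_l gap (E (xt t) - W0)). pose proof (Rmin_r gap (E (xt t) - W0)).
    assert (Hdd : 0 < dd) by (apply Rmin_pos; unfold W0 in *; lra).
    destruct (Heps dd Hdd ltac:(unfold dd; lra)) as [Hd1 [Hd2 Hd3]].
    destruct (trap_inv_holds _ t Hd1 Hd2 Ht t ltac:(lra)) as [_ Hd4]. unfold dd, W0 in *. lra.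
Qed.

Lemma no_jump t l : K t l -> l = O.
Proof.
  intro Ht. destruct (Nat.eq_dec l O) as [E0|E0]; auto. exfalso.
  pose proof Hsol as [Hd [_ [_ [_ Hj]]]].
  destruct (hybrid_time_domain_first_jump K Hd t l Ht E0) as [t1 [K1 K1']].
  destruct (Hj t1 O K1 K1') as [[_ [j Hj']] _].
  destruct (trap t1 K1) as [[_ [Hom _]] _]. specialize (Hom j). pose proof (Hr_w0 j). pose proof (Hw j).
  rewrite (sg_zero t1 K1 j) in Hj'.
  destruct Hj' as [[A B]|[A B]]; lra.
Qed.

Section Unbounded.
Hypothesis Hunb : forall t, 0 <= t -> K t O.

Lemma traj_derivable_pos t : 0 < t -> forall c,
  derivable_pt_lim (fun s => coord_val Nw (xt s) c) t (coord_rhs Nw (xt t) c).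
Proof. intros Ht c. apply (traj_derivable t (t + 1)); [apply Hunb|]; lra. Qed.

Lemma traj_in_obox t : 0 <= t -> in_obox (xt t).
Proof. intro Ht. apply (trap t (Hunb t Ht)). Qed.

Lemma energy_traj_derivable t : 0 < t -> derivable_pt_lim (fun s => E (xt s)) t (energy_rate Nw xst G (xt t)).
Proof. intro Ht. apply energy_derivative; auto. intro c. apply traj_derivable_pos; auto. Qed.

Lemma energy_traj_nonincreasing a b : 0 < a <= b -> E (xt b) <= E (xt a).
Proof.
  intro Hab. assert (E (xt b) - E (xt a) <= 0 * (b - a)); [|lra].
  apply (mean_value_le (fun s => E (xt s))); [lra|]. intros t Ht. exists (energy_rate Nw xst G (xt t)).
  split; [apply energy_traj_derivable; lra|]. apply energy_rate_nonpos, in_obox_cbox, traj_in_obox. lra.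
Qed.

Lemma coord_traj_lipschitz Lx : (forall x, in_cbox x -> forall c, Rabs (coord_rhs Nw x c) <= Lx) ->
  forall c a b, 0 < a <= b -> Rabs (coord_val Nw (xt b) c - coord_val Nw (xt a) c) <= Lx * (b - a).
Proof.
  intros HL c a b Hab.
  assert (Hd : forall t, a <= t <= b -> derivable_pt_lim (fun s => coord_val Nw (xt s) c) t (coord_rhs Nw (xt t) c) /\
                 - Lx <= coord_rhs Nw (xt t) c <= Lx)
    by (intros t Ht; split; [apply traj_derivable_pos; lra|];
        apply Rabs_le_inv, HL, in_obox_cbox, traj_in_obox; lra).
  apply Rabs_le. split.
  - assert (- Lx * (b - a) <= coord_val Nw (xt b) c - coord_val Nw (xt a) c); [|lra].
    apply (mean_value_ge (fun s => coord_val Nw (xt s) c)); [lra|].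
    intros t Ht. exists (coord_rhs Nw (xt t) c). split; apply Hd; auto.
  - apply (mean_value_le (fun s => coord_val Nw (xt s) c)); [lra|].
    intros t Ht. exists (coord_rhs Nw (xt t) c). split; apply Hd; auto.
Qed.

Lemma energy_rate_le_gap x j : in_cbox x -> energy_rate Nw xst G x <= - passivity_gap Nw xst G j (xs x j) (- om x j).
Proof.
  intro Hx. rewrite energy_rate_dissipation by auto. apply Ropp_le_contravar.
  apply (fsum_ge_term _ (fun j => passivity_gap Nw xst G j (xs x j) (- om x j))). intro i.
  pose proof (passivity_gap_ge x i Hx). pose proof (ph_nonneg i (- om x i)). lra.
Qed.

(* While some frequency is at least eps, the dissipation at that bus stays bounded below for a
   fixed time, so the energy drops by a fixed amount. *)
Lemma energy_drop_when_om_large eps : 0 < eps <= r -> exists tau dE, 0 < tau /\ 0 < dE /\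
  forall t j, 1 <= t -> eps <= Rabs (om (xt t) j) -> E (xt (t + tau)) <= E (xt t) - dE.
Proof.
  intro He. set (e := eps / 2).
  destruct (passivity_gap_lower_bound e ltac:(unfold e; lra)) as [mm [Hmm Hmm']].
  destruct coord_rhs_bounded_in_cbox as [Lx [HLx HLx']].
  set (tau := e / Lx). assert (Htau : 0 < tau) by (unfold tau, e; apply Rdiv_lt_0_compat; lra).
  exists tau, (mm * tau). split; [auto|split; [nra|]]. intros t j Ht Hj.
  assert (E (xt (t + tau)) - E (xt t) <= - mm * (t + tau - t)); [|lra].
  apply (mean_value_le (fun s => E (xt s))); [lra|]. intros s Hs. exists (energy_rate Nw xst G (xt s)).
  split; [apply energy_traj_derivable; lra|].
  assert (HRs : in_cbox (xt s)) by (apply in_obox_cbox, traj_in_obox; lra).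
  pose proof (coord_traj_lipschitz Lx HLx' (CO j) t s ltac:(lra)) as Hmv. simpl in Hmv.
  assert (Lx * (s - t) <= e)
    by (apply Rle_trans with (Lx * tau); [apply Rmult_le_compat_l; lra|unfold tau; right; field; lra]).
  assert (Hu : e <= Rabs (- om (xt s) j) <= r).
  { rewrite Rabs_Ropp. destruct HRs as [_ [Hom _]]. split; auto.
    pose proof (Rabs_triang_inv (om (xt t) j) (om (xt s) j)). rewrite Rabs_minus_sym in Hmv. unfold e in *. lra. }
  pose proof (Hmm' j (xs (xt s) j) (- om (xt s) j) (proj2 (proj2 HRs) j) Hu).
  pose proof (energy_rate_le_gap (xt s) j HRs). lra.
Qed.

Lemma om_tends_to_zero eps : 0 < eps -> exists T, 0 <= T /\ forall t, T <= t -> forall j, Rabs (om (xt t) j) < eps.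
Proof.
  intro He. apply NNPP. intro Hn.
  assert (Hbad : forall T, exists t j, T <= t /\ eps <= Rabs (om (xt t) j)).
  { intro T. apply NNPP. intro Hn2. apply Hn. exists (Rmax 0 T). split; [apply Rmax_l|].
    intros t Ht j. apply Rnot_le_lt. intro Hle. apply Hn2. exists t, j. split; auto.
    pose proof (Rmax_r 0 T). lra. }
  destruct (Hbad 0) as [t0 [j0 [Ht0 Hj0]]]. destruct (traj_in_obox t0 Ht0) as [_ [Hr0 _]]. specialize (Hr0 j0).
  destruct (energy_drop_when_om_large eps ltac:(lra)) as [tau [dE [Htau [HdE Hdrop]]]].
  assert (Iter : forall k : nat, exists t, 1 <= t /\ E (xt t) <= E (xt 1) - INR k * dE).
  { induction k as [|k [tk [Htk Htk']]]; [exists 1; simpl; lra|].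
    destruct (Hbad tk) as [t' [j [Ht' Hj]]]. exists (t' + tau). split; [lra|].
    specialize (Hdrop t' j ltac:(lra) Hj). pose proof (energy_traj_nonincreasing tk t' ltac:(lra)).
    rewrite S_INR. lra. }
  destruct (INR_unbounded (E (xt 1) / dE)) as [k Hk].
  destruct (Iter k) as [t [Ht Ht']]. pose proof (energy_nonneg (xt t) (in_obox_cbox _ (traj_in_obox t ltac:(lra)))).
  assert (E (xt 1) < INR k * dE); [|lra].
  apply Rmult_lt_reg_r with (/ dE); [apply Rinv_0_lt_compat; auto|].
  rewrite Rmult_assoc, Rinv_r, Rmult_1_r by lra. exact Hk.
Qed.

Section LimitSet.
Variable j : Fin.t (nN Nw).

Definition xs_limit (p : Vec (nd Nw j)) :=
  forall eps, 0 < eps -> forall T, exists t, T <= t /\ vnorm (vsub (xs (xt t) j) p) < eps.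

Lemma xs_limit_compact : vcompact xs_limit.
Proof.
  split.
  - exists (1 + r + vnorm (xs xst j)). intros p Hp. destruct (Hp 1 ltac:(lra) 0) as [t [Ht Ht']].
    destruct (traj_in_obox t Ht) as [_ [_ H3]]. specialize (H3 j).
    pose proof (vnorm_le_vsub _ p (xs (xt t) j)). pose proof (vnorm_le_vsub _ (xs (xt t) j) (xs xst j)).
    rewrite vnorm_vsub_sym in Ht'. lra.
  - intros x Hx eps He T. destruct (Hx (eps/2) ltac:(lra)) as [y [Hy Hxy]].
    destruct (Hy (eps/2) ltac:(lra) T) as [t [Ht Ht']]. exists t. split; auto.
    pose proof (vnorm_vsub_triang _ (xs (xt t) j) y x). rewrite (vnorm_vsub_sym _ y x) in *. lra.
Qed.

Variables (phi : R -> Vec (nd Nw j)) (L eta : R).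
Hypothesis Hphi : ode_solution (fun x => fs Nw j x (- 0)) phi.
Hypothesis HL : 0 < L.
Hypothesis HLf : forall x y u v, vnorm (vsub (fs Nw j x u) (fs Nw j y v)) <= L * (vnorm (vsub x y) + Rabs (u - v)).
Hypothesis Heta : 0 < eta.

(* Once the frequencies are small, x^s_j shadows the frozen dynamics x' = f_j(x, 0), forwards
   and backwards in time (Gronwall). *)
Lemma frozen_tracking_forward s tau : 0 < s -> 0 <= tau ->
  (forall t, s <= t <= s + tau -> Rabs (om (xt t) j) < eta) ->
  vnorm (vsub (xs (xt (s + tau)) j) (phi tau)) <=
    (vnorm (vsub (xs (xt s) j) (phi 0)) + eta + (L * eta + eta) * tau) * exp (L * tau).
Proof.
  intros Hs Htau Hom.
  assert (Hg : vnorm (vsub (xs (xt (s + tau)) j) (phi tau)) <=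
      (vnorm (vsub (xs (xt (s + 0)) j) (phi 0)) + eta + (L * eta + eta) * tau) * exp (L * tau)).
  { apply (gronwall_vec _ (fun u => xs (xt (s + u)) j) phi
             (fun u => fs Nw j (xs (xt (s + u)) j) (- om (xt (s + u)) j)) (fun u => fs Nw j (phi u) (- 0))
             tau L eta eta Htau HL Heta (Rlt_le _ _ Heta)); [| |lra].
    - intros t Ht k. split; [|apply Hphi].
      apply (derivable_pt_lim_shift (fun u => xs (xt u) j k)).
      exact (traj_derivable_pos (s + t) ltac:(lra) (CX j k)).
    - intros t Ht. eapply Rle_trans; [apply HLf|].
      replace (- om (xt (s + t)) j - - 0) with (- om (xt (s + t)) j) by ring. rewrite Rabs_Ropp.
      specialize (Hom (s + t) ltac:(lra)). nra. }
  rewrite Rplus_0_r in Hg. exact Hg.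
Qed.

Lemma frozen_tracking_backward s A : 0 <= A -> 0 < s - A ->
  (forall t, s - A <= t <= s -> Rabs (om (xt t) j) < eta) ->
  vnorm (vsub (xs (xt (s - A)) j) (phi (- A))) <=
    (vnorm (vsub (xs (xt s) j) (phi 0)) + eta + (L * eta + eta) * A) * exp (L * A).
Proof.
  intros HA Hs Hom.
  assert (Hg : vnorm (vsub (xs (xt (s - A)) j) (phi (- A))) <=
      (vnorm (vsub (xs (xt (s - 0)) j) (phi (- 0))) + eta + (L * eta + eta) * A) * exp (L * A)).
  { apply (gronwall_vec _ (fun u => xs (xt (s - u)) j) (fun u => phi (- u))
             (fun u k => - fs Nw j (xs (xt (s - u)) j) (- om (xt (s - u)) j) k)
             (fun u k => - fs Nw j (phi (- u)) (- 0) k) A L eta eta HA HL Heta (Rlt_le _ _ Heta)); [| |lra].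
    - intros t Ht k. split.
      + apply (derivable_pt_lim_reflect (fun u => xs (xt u) j k)).
        exact (traj_derivable_pos (s - t) ltac:(lra) (CX j k)).
      + replace (- fs Nw j (phi (- t)) (- 0) k) with (fs Nw j (phi (- t)) (- 0) k * (- 1)) by ring.
        apply (derivable_pt_lim_comp (fun u => - u) (fun u => phi u k)); [|apply Hphi].
        apply derivable_pt_lim_opp, derivable_pt_lim_id.
    - intros t Ht. rewrite vnorm_vsub_opp. eapply Rle_trans; [apply HLf|].
      replace (- om (xt (s - t)) j - - 0) with (- om (xt (s - t)) j) by ring. rewrite Rabs_Ropp.
      specialize (Hom (s - t) ltac:(lra)). nra. }
  rewrite Rminus_0_r, Ropp_0 in Hg. exact Hg.
Qed.

End LimitSet.

Lemma xs_limit_invariant j : invariant_set (fun x => fs Nw j x (- 0)) (xs_limit j).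
Proof.
  intros phi Hphi H0 tau0 eps' He' T.
  destruct (lipschitz_pos _ _ (Hlip j)) as [L [HL HL']].
  assert (HLf : forall x y u v, vnorm (vsub (fs Nw j x u) (fs Nw j y v)) <= L * (vnorm (vsub x y) + Rabs (u - v)))
    by (intros; apply HL').
  set (A := Rabs tau0). assert (HA : 0 <= A) by apply Rabs_pos. pose proof (exp_pos (L * A)).
  (* eta is tuned so that the Gronwall bound below is eps' / 2 *)
  set (eta := eps' / (2 * (2 + (L + 1) * A) * exp (L * A))).
  assert (Heta : 0 < eta) by (apply Rdiv_lt_0_compat; auto; apply Rmult_lt_0_compat; nra).
  assert (Hfin : (eta + eta + (L * eta + eta) * A) * exp (L * A) = eps' / 2) by (unfold eta; field; split; nra).
  destruct (om_tends_to_zero eta Heta) as [T1 [HT1 HT1']].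
  pose proof (Rmax_l (T + A) (Rmax (T1 + A) (1 + A))). pose proof (Rmax_r (T + A) (Rmax (T1 + A) (1 + A))).
  pose proof (Rmax_l (T1 + A) (1 + A)). pose proof (Rmax_r (T1 + A) (1 + A)).
  destruct (H0 eta Heta (Rmax (T + A) (Rmax (T1 + A) (1 + A)))) as [s [Hs Hs']].
  pose proof (Rle_abs tau0). pose proof (Rle_abs (- tau0)). rewrite Rabs_Ropp in *.
  exists (s + tau0). split; [unfold A in *; lra|].
  destruct (Rle_dec 0 tau0) as [Hpos|Hneg].
  - assert (HA' : A = tau0) by (unfold A; rewrite Rabs_right; lra).
    pose proof (frozen_tracking_forward j phi L eta Hphi HL HLf Heta s tau0 ltac:(lra) Hpos
                  (fun t Ht => HT1' t ltac:(lra) j)). rewrite <- HA' in *. nra.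
  - assert (HA' : A = - tau0) by (unfold A; rewrite Rabs_left; lra).
    pose proof (frozen_tracking_backward j phi L eta Hphi HL HLf Heta s A HA ltac:(lra)
                  (fun t Ht => HT1' t ltac:(lra) j)).
    replace (s - A) with (s + tau0) in * by lra. replace (- A) with tau0 in * by lra. nra.
Qed.

Lemma xs_limit_equilibrium j p : xs_limit j p -> forall k, fs Nw j p (- 0) k = 0.
Proof. intro Hp. apply (A1ii j (xs_limit j)); auto; [apply xs_limit_compact|apply xs_limit_invariant]. Qed.

Lemma traj_limit_point (ts : nat -> R) : (forall n, 0 <= ts n) ->
  exists phi : nat -> nat, (forall n, (phi n < phi (S n))%nat) /\
  exists p, forall c, Un_cv (fun n => coord_val Nw (xt (ts (phi n))) c) (coord_val Nw p c).
Proof.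
  intro Hts0. destruct coord_bounded_in_cbox as [B HB'].
  destruct (bolzano_weierstrass_list (coord_list Nw) (fun n c => coord_val Nw (xt (ts n)) c) B) as [phi [Hphi Hcv]].
  { intros n c. apply HB', in_obox_cbox, traj_in_obox. auto. }
  assert (Hcv' : forall c, exists L, Un_cv (fun n => coord_val Nw (xt (ts (phi n))) c) L)
    by (intro c; apply Hcv, coord_list_in).
  set (Lf := fun c => proj1_sig (constructive_indefinite_description _ (Hcv' c))).
  exists phi. split; auto. exists (of_coords Nw Lf). intro c. rewrite coord_val_of_coords.
  unfold Lf. destruct (constructive_indefinite_description _ (Hcv' c)); auto.
Qed.

Section LimitPoint.
Variables (tn : nat -> R) (p : state Nw).
Hypothesis Htn : forall n, INR n <= tn n.
Hypothesis Hp : forall c, Un_cv (fun n => coord_val Nw (xt (tn n)) c) (coord_val Nw p c).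

Lemma limit_point_late T eps : 0 < eps -> exists n, T <= tn n /\ xclose eps (xt (tn n)) p.
Proof.
  intro He. destruct (Un_cv_xclose Nw _ p Hp eps He) as [N HN]. destruct (INR_unbounded T) as [N2 HN2].
  exists (Nat.max N N2). split; [|apply HN; lia].
  specialize (Htn (Nat.max N N2)). assert (INR N2 <= INR (Nat.max N N2)) by (apply le_INR; lia). lra.
Qed.

Lemma limit_point_om_zero j : om p j = 0.
Proof.
  apply NNPP. intro Hne. set (a := Rabs (om p j)). assert (Ha : 0 < a) by (apply Rabs_pos_lt; auto).
  destruct (om_tends_to_zero (a/2) ltac:(lra)) as [T [HT HT']].
  destruct (limit_point_late T (a/2) ltac:(lra)) as [n [Hn [_ [Hc _]]]].
  specialize (Hc j). specialize (HT' (tn n) Hn j).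
  pose proof (Rabs_triang_inv (om p j) (om (xt (tn n)) j)). rewrite Rabs_minus_sym in Hc. unfold a in *. lra.
Qed.

Lemma limit_point_xs_limit j : xs_limit j (xs p j).
Proof.
  intros e' He' T. pose proof (pos_INR (nd Nw j)).
  destruct (limit_point_late T (e' / (INR (nd Nw j) + 1)) ltac:(apply Rdiv_lt_0_compat; lra)) as [n [Hn Hc]].
  exists (tn n). split; auto. eapply Rle_lt_trans; [apply (xclose_vnorm_xs Nw _ _ _ j Hc)|].
  apply Rmult_lt_reg_r with (INR (nd Nw j) + 1); [lra|].
  replace (INR (nd Nw j) * (e' / (INR (nd Nw j) + 1)) * (INR (nd Nw j) + 1)) with (INR (nd Nw j) * e') by (field; lra).
  nra.
Qed.

(* The trajectory returns close to p infinitely often and, its speed being bounded, stays close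
   for a time tau independent of the return. *)
Lemma limit_point_dwell d : 0 < d -> exists tau, 0 < tau /\ forall T, exists t1, T <= t1 /\
  forall s, t1 <= s <= t1 + tau -> xclose d p (xt s).
Proof.
  intro Hd. destruct coord_rhs_bounded_in_cbox as [Lx [HLx HLx']].
  set (tau := d / (2 * Lx)). assert (Htau : 0 < tau) by (apply Rdiv_lt_0_compat; lra).
  exists tau. split; auto. intro T.
  destruct (limit_point_late (Rmax T 1) (d/2) ltac:(lra)) as [n [Hn Hc]].
  pose proof (Rmax_l T 1). pose proof (Rmax_r T 1).
  exists (tn n). split; [lra|]. intros s Hs. apply xclose_iff_coords. intro c.
  apply xclose_sym in Hc. rewrite xclose_iff_coords in Hc. specialize (Hc c).
  pose proof (coord_traj_lipschitz Lx HLx' c (tn n) s ltac:(lra)).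
  assert (Lx * (s - tn n) <= d / 2)
    by (apply Rle_trans with (Lx * tau); [apply Rmult_le_compat_l; lra|unfold tau; right; field; lra]).
  replace (coord_val Nw p c - coord_val Nw (xt s) c) with
    ((coord_val Nw p c - coord_val Nw (xt (tn n)) c) - (coord_val Nw (xt s) c - coord_val Nw (xt (tn n)) c)) by ring.
  eapply Rle_lt_trans; [apply Rabs_triang|]. rewrite Rabs_Ropp. lra.
Qed.

(* If the frequency derivative at p were c0 <> 0, omega_j would move by about c0 * tau near p,
   contradicting omega -> 0. *)
Lemma limit_point_om_rhs_zero j : om_rhs Nw p j = 0.
Proof.
  apply NNPP. intro Hne. set (c0 := Rabs (om_rhs Nw p j)). assert (Hc0 : 0 < c0) by (apply Rabs_pos_lt; auto).
  destruct (coord_rhs_lipschitz Nw HM HB Hlip (CO j)) as [Lc [HLc HLc']]. simpl in HLc'.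
  set (d := c0 / (2 * (Lc + 1))). assert (Hd : 0 < d) by (apply Rdiv_lt_0_compat; lra).
  assert (Hclose : forall y, xclose d p y -> Rabs (om_rhs Nw y j - om_rhs Nw p j) < c0 / 2).
  { intros y Hy. specialize (HLc' p y d ltac:(lra) Hy). rewrite Rabs_minus_sym. eapply Rle_lt_trans; [apply HLc'|].
    unfold d. apply Rmult_lt_reg_r with (2 * (Lc + 1)); [lra|].
    replace (Lc * (c0 / (2 * (Lc + 1))) * (2 * (Lc + 1))) with (Lc * c0) by (field; lra). nra. }
  destruct (limit_point_dwell d Hd) as [tau [Htau Hdwell]].
  destruct (om_tends_to_zero (c0 * tau / 8)) as [T2 [HT2 HT2']]; [apply Rdiv_lt_0_compat; [nra|lra]|].
  destruct (Hdwell (Rmax T2 1)) as [t1 [Ht1 Hin]]. pose proof (Rmax_l T2 1). pose proof (Rmax_r T2 1).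
  assert (Hd1 : forall s, t1 <= s <= t1 + tau ->
            derivable_pt_lim (fun s => om (xt s) j) s (om_rhs Nw (xt s) j) /\
            Rabs (om_rhs Nw (xt s) j - om_rhs Nw p j) < c0 / 2)
    by (intros s Hs; split; [apply (traj_derivable_pos s ltac:(lra) (CO j))|apply Hclose, Hin; auto]).
  pose proof (HT2' t1 ltac:(lra) j) as Hw1. pose proof (HT2' (t1 + tau) ltac:(lra) j) as Hw2.
  apply Rabs_def2 in Hw1. apply Rabs_def2 in Hw2.
  destruct (Rle_dec 0 (om_rhs Nw p j)).
  - assert (om_rhs Nw p j = c0) by (unfold c0; rewrite Rabs_right; lra).
    assert (c0 / 2 * (t1 + tau - t1) <= om (xt (t1 + tau)) j - om (xt t1) j); [|nra].
    apply (mean_value_ge (fun s => om (xt s) j)); [lra|]. intros s Hs. exists (om_rhs Nw (xt s) j).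
    destruct (Hd1 s Hs) as [Hder Hnear]. apply Rabs_def2 in Hnear. split; auto; lra.
  - assert (om_rhs Nw p j = - c0) by (unfold c0; rewrite Rabs_left; lra).
    assert (om (xt (t1 + tau)) j - om (xt t1) j <= - (c0 / 2) * (t1 + tau - t1)); [|nra].
    apply (mean_value_le (fun s => om (xt s) j)); [lra|]. intros s Hs. exists (om_rhs Nw (xt s) j).
    destruct (Hd1 s Hs) as [Hder Hnear]. apply Rabs_def2 in Hnear. split; auto; lra.
Qed.

Lemma limit_point_equilibrium : equilibrium (mkH p (fun _ => 0%Z)).
Proof.
  assert (HinC : inC (mkH p (fun _ => 0%Z))).
  { intro j. change (inI (w0 Nw j) (w1 Nw j) (om p j) 0%Z). rewrite limit_point_om_zero.
    right. left. rewrite Rabs_R0. split; [apply Hw|auto]. }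
  split; [left; auto|split].
  - intros _. split; [|split].
    + intro e. unfold flow_eta. simpl. rewrite !limit_point_om_zero. ring.
    + intro j. rewrite flow_om_sg0 by auto. apply limit_point_om_rhs_zero.
    + intros j k. unfold flow_xs. simpl. rewrite limit_point_om_zero. apply xs_limit_equilibrium, limit_point_xs_limit.
  - intros [_ [j Hj]]. simpl in Hj. rewrite limit_point_om_zero, Rabs_R0 in Hj. pose proof (Hw j).
    exfalso. destruct Hj as [[A _]|[A _]]; lra.
Qed.

End LimitPoint.

Lemma converges_unbounded : converges_to_equilibria K z.
Proof.
  intros eps He. apply NNPP. intro Hn.
  assert (Hbad : forall n : nat, exists t, INR n <= t /\ ~ exists ze, equilibrium ze /\ zclose eps (z t O) ze).
  { intro n. apply NNPP. intro Hn2. apply Hn. exists (INR n). intros t l Ht Htl.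
    rewrite (no_jump t l Ht) in *. simpl in Htl. rewrite Rplus_0_r in Htl.
    apply NNPP. intro Hn3. apply Hn2. exists t. split; auto. }
  set (ts := fun n => proj1_sig (constructive_indefinite_description _ (Hbad n))).
  assert (Hts : forall n, INR n <= ts n /\ ~ exists ze, equilibrium ze /\ zclose eps (z (ts n) O) ze)
    by (intro n; unfold ts; destruct (constructive_indefinite_description _ (Hbad n)); auto).
  destruct (traj_limit_point ts) as [phi [Hphi [p Hp]]].
  { intro n. pose proof (pos_INR n). pose proof (proj1 (Hts n)). lra. }
  assert (Htn : forall n, INR n <= ts (phi n)).
  { intro n. pose proof (proj1 (Hts (phi n))). pose proof (strict_incr_ge_id phi Hphi n). apply le_INR in H0. lra. }
  destruct (Un_cv_xclose Nw _ p Hp eps He) as [N HN].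
  apply (proj2 (Hts (phi N))). exists (mkH p (fun _ => 0%Z)).
  split; [apply (limit_point_equilibrium (fun n => ts (phi n))); auto|]. split; [apply (HN N (le_n N))|].
  intro j. simpl. rewrite (sg_zero _ (Hunb _ (Rle_trans _ _ _ (pos_INR _) (proj1 (Hts (phi N))))) j).
  rewrite Rminus_0_r, Rabs_R0. auto.
Qed.

End Unbounded.

Lemma solution_converges : converges_to_equilibria K z /\ omega_sigma_to_zero K z.
Proof.
  destruct (classic (exists B, forall t, K t O -> t <= B)) as [[B HB']|Hnb].
  - assert (Hv : forall t l, K t l -> B + 1 <= t + INR l -> False).
    { intros t l Ht Htl. pose proof (no_jump t l Ht). subst l. simpl in Htl. specialize (HB' t Ht). lra. }
    split; [|split]; intros eps He; exists (B + 1); intros t l Ht Htl; exfalso; eapply Hv; eauto.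
  - assert (Hunb : forall t, 0 <= t -> K t O).
    { intros t Ht. apply NNPP. intro Hn. apply Hnb. exists t. intros t' Ht'. apply Rnot_lt_le. intro Hlt.
      apply Hn, (dom_down t'); auto. lra. }
    split; [apply (converges_unbounded Hunb)|split].
    + intros eps He. destruct (om_tends_to_zero Hunb eps He) as [T [HT HT']]. exists T.
      intros t l Ht Htl j. pose proof (no_jump t l Ht). subst l. simpl in Htl. rewrite Rplus_0_r in Htl. auto.
    + intros eps He. exists 0. intros t l Ht Htl j. pose proof (no_jump t l Ht). subst l.
      rewrite (sg_zero t Ht j). simpl IZR. rewrite Rabs_R0. auto.
Qed.

End Trajectory.

Theorem lyapunov_attractivity : exists S : state Nw -> Prop, open_states S /\ S xst /\
  forall (K : R -> nat -> Prop) (z : R -> nat -> hstate Nw), is_solution K z -> S (hx (z 0 O)) ->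
    (forall j, inI (w0 Nw j) (w1 Nw j) (om (hx (z 0 O)) j) (sg (z 0 O) j)) ->
    converges_to_equilibria K z /\ omega_sigma_to_zero K z.
Proof.
  destruct energy_boundary_gap as [m [Hm Hbd]].
  exists (fun x => in_obox x /\ E x < m). split; [|split].
  - intros x [Hx1 Hx2]. destruct (in_obox_open x Hx1) as [d1 [Hd1 H1]].
    destruct (energy_continuous x (m - E x) ltac:(lra)) as [d2 [Hd2 H2]].
    exists (Rmin d1 d2). split; [apply Rmin_pos; auto|]. intros y Hy. split.
    + apply H1. eapply xclose_weaken; [|apply Hy]. apply Rmin_l.
    + assert (Hy2 : xclose d2 x y) by (eapply xclose_weaken; [|apply Hy]; apply Rmin_r).
      specialize (H2 y Hy2). apply Rabs_def2 in H2. lra.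
  - split; [apply in_obox_eq|]. rewrite energy_eq. auto.
  - intros K z Hsol HS0 HI0. apply (solution_converges m Hbd K z Hsol HS0 HI0).
Qed.

End Lyapunov.

Lemma dependent_choice {I : Type} {A : I -> Type} (P : forall i, A i -> Prop) :
  (forall i, exists a, P i a) -> exists f : forall i, A i, forall i, P i (f i).
Proof.
  intro H. exists (fun i => proj1_sig (constructive_indefinite_description _ (H i))).
  intro i. exact (proj2_sig (constructive_indefinite_description _ (H i))).
Qed.

Section Equilibrium.
Variable Nw : Net.
Variable zs : hstate Nw.
Hypothesis Heq : equilibrium zs.

Lemma equilibrium_inC : inC zs.
Proof. destruct Heq as [[H|[H _]] _]; auto. Qed.

(* Zero angle rates make the frequency constant along every line, hence, the network being
   connected, equal at all buses; (A2) pins that common value to 0. *)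
Lemma equilibrium_om_zero : (forall i j, clos_refl_trans _ (adjacent Nw) i j) ->
  (exists j, forall (xb : Vec (nd Nw j)) (wb : R), (forall k, fs Nw j xb (- wb) k = 0) -> wb = 0) ->
  forall j, om (hx zs) j = 0.
Proof.
  intros Hconn [j0 Hj0]. destruct Heq as [_ [Hflow _]].
  destruct (Hflow equilibrium_inC) as [Feta [_ Fxs]].
  assert (Hsame : forall i j, clos_refl_trans _ (adjacent Nw) i j -> om (hx zs) i = om (hx zs) j).
  { intros i j H. induction H as [i j [e [[Hs Hd]|[Hs Hd]]]| |i j k _ IH1 _ IH2]; try congruence;
      specialize (Feta e); unfold flow_eta in Feta; subst; lra. }
  intro j. rewrite <- (Hsame j0 j (Hconn j0 j)). apply (Hj0 (xs (hx zs) j0)), Fxs.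
Qed.

Lemma equilibrium_sg_zero : (forall j, 0 < w0 Nw j < w1 Nw j) -> (forall j, om (hx zs) j = 0) -> forall j, sg zs j = 0%Z.
Proof.
  intros Hw Hom j. pose proof equilibrium_inC as HC. specialize (HC j). unfold inI in HC.
  rewrite Hom, Rabs_R0 in HC. specialize (Hw j). destruct HC as [[A B]|[[A B]|[A B]]]; auto; lra.
Qed.

Lemma equilibrium_power_balance : (forall j, 0 < Mc Nw j) -> (forall j, 0 < w0 Nw j < w1 Nw j) ->
  (forall j, om (hx zs) j = 0) ->
  forall j, - pL Nw j + gs Nw j (xs (hx zs) j) 0 - out_flow Nw (hx zs) j + in_flow Nw (hx zs) j = 0.
Proof.
  intros HM Hw Hom j. destruct Heq as [_ [Hflow _]]. destruct (Hflow equilibrium_inC) as [_ [Fom _]].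
  specialize (Fom j). rewrite flow_om_sg0 in Fom by (apply equilibrium_sg_zero; auto).
  unfold om_rhs in Fom. rewrite Hom, Ropp_0 in Fom. specialize (HM j).
  apply (Rmult_eq_compat_r (Mc Nw j)) in Fom. unfold Rdiv in Fom. rewrite Rmult_assoc, Rinv_l in Fom by lra. lra.
Qed.

End Equilibrium.

Definition storage_on_box (Nw : Net) (xst : state Nw) j (V : Vec (nd Nw j) -> R) (G : Vec (nd Nw j) -> Vec (nd Nw j))
    (ph : R -> R) (rho : R) : Prop :=
  rho < w0 Nw j /\
  (forall u y, Rabs u <= rho -> vnorm (vsub y (xs xst j)) <= rho ->
     vdot (G y) (fs Nw j y u) <= (u - 0) * (gs Nw j y u - gs Nw j (xs xst j) 0) - ph (u - 0)) /\
  (exists d, rho < d /\ forall y, 0 < vnorm (vsub y (xs xst j)) < d -> V (xs xst j) < V y).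

Lemma storage_on_box_mono Nw xst j V G ph rho rho' :
  0 < rho' <= rho -> storage_on_box Nw xst j V G ph rho -> storage_on_box Nw xst j V G ph rho'.
Proof.
  intros Hr [A [B [d [C D]]]]. split; [lra|split]; [intros u y Hu Hy; apply B; lra|]. exists d. split; auto. lra.
Qed.

Lemma storage_on_small_box Nw xst j V : 0 < w0 Nw j ->
  loc_ISP (fs Nw j) (gs Nw j) 0 (xs xst j) V -> strict_local_min V (xs xst j) ->
  exists G ph, C1_with_grad V G /\ pos_def ph /\ exists rho, 0 < rho /\ storage_on_box Nw xst j V G ph rho.
Proof.
  intros Hw [Om [X [G [ph [HOm [HOm0 [HX [HX0 [HC1 [_ [Hph Hpass]]]]]]]]]]] [dV [HdV HdV']].
  exists G, ph. split; auto. split; auto.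
  destruct (HOm 0 HOm0) as [dO [HdO HdO']]. destruct (HX _ HX0) as [dX [HdX HdX']].
  set (rho := Rmin (w0 Nw j) (Rmin dO (Rmin dX dV)) / 2).
  pose proof (Rmin_l (w0 Nw j) (Rmin dO (Rmin dX dV))). pose proof (Rmin_r (w0 Nw j) (Rmin dO (Rmin dX dV))).
  pose proof (Rmin_l dO (Rmin dX dV)). pose proof (Rmin_r dO (Rmin dX dV)).
  pose proof (Rmin_l dX dV). pose proof (Rmin_r dX dV).
  assert (0 < Rmin (w0 Nw j) (Rmin dO (Rmin dX dV))) by (repeat apply Rmin_pos; lra).
  exists rho. unfold rho. split; [lra|split; [lra|split]].
  - intros u y Hu Hy. apply Hpass; [apply HdO'; rewrite Rminus_0_r; lra|apply HdX'; lra].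
  - exists dV. split; [lra|auto].
Qed.

Lemma storage_choice Nw xst : (forall j, 0 < w0 Nw j) ->
  (forall j, exists V : Vec (nd Nw j) -> R,
     loc_ISP (fs Nw j) (gs Nw j) 0 (xs xst j) V /\ strict_local_min V (xs xst j)) ->
  exists (V : forall j, Vec (nd Nw j) -> R) (G : forall j, Vec (nd Nw j) -> Vec (nd Nw j)) (ph : Fin.t (nN Nw) -> R -> R),
    (forall j, C1_with_grad (V j) (G j)) /\ (forall j, pos_def (ph j)) /\
    exists r, 0 < r /\ forall j, storage_on_box Nw xst j (V j) (G j) (ph j) r.
Proof.
  intros Hw A3.
  destruct (dependent_choice (fun j (V : Vec (nd Nw j) -> R) => exists G ph, C1_with_grad V G /\ pos_def ph /\
              exists rho, 0 < rho /\ storage_on_box Nw xst j V G ph rho)) as [V HV].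
  { intro j. destruct (A3 j) as [V [H1 H2]]. exists V. apply storage_on_small_box; auto. }
  destruct (dependent_choice (fun j (G : Vec (nd Nw j) -> Vec (nd Nw j)) => exists ph, C1_with_grad (V j) G /\
              pos_def ph /\ exists rho, 0 < rho /\ storage_on_box Nw xst j (V j) G ph rho) HV) as [G HG].
  destruct (dependent_choice (fun j (ph : R -> R) => C1_with_grad (V j) (G j) /\
              pos_def ph /\ exists rho, 0 < rho /\ storage_on_box Nw xst j (V j) (G j) ph rho) HG) as [ph Hph].
  exists V, G, ph. split; [apply Hph|split; [apply Hph|]].
  apply fin_common_radius; [|intro j; apply Hph].
  intros j d d' Hd. apply storage_on_box_mono. lra.
Qed.

Theorem theorem2 (Nw : Net) (HNw : net_assumptions Nw)
  (A1i : forall j, exists x0 : Vec (nd Nw j), forall k, fs Nw j x0 0 k = 0)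
  (A1ii : forall j (wb : R) (M : Vec (nd Nw j) -> Prop),
      vcompact M -> invariant_set (fun x => fs Nw j x (- wb)) M ->
      forall x, M x -> forall k, fs Nw j x (- wb) k = 0)
  (A2 : exists j, forall (xb : Vec (nd Nw j)) (wb : R),
      (forall k, fs Nw j xb (- wb) k = 0) -> wb = 0)
  (zs : hstate Nw) (Heq : equilibrium zs)
  (A3 : forall j, exists V : Vec (nd Nw j) -> R,
      loc_ISP (fs Nw j) (gs Nw j) 0 (xs (hx zs) j) V /\
      strict_local_min V (xs (hx zs) j))
  (A4 : forall e, Rabs (eta (hx zs) e) < PI / 2) :
  exists S : state Nw -> Prop,
    open_states S /\ S (hx zs) /\
    forall (K : R -> nat -> Prop) (z : R -> nat -> hstate Nw),
      maximal_solution K z ->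
      S (hx (z 0 O)) ->
      (forall j, inI (w0 Nw j) (w1 Nw j) (om (hx (z 0 O)) j) (sg (z 0 O) j)) ->
      converges_to_equilibria K z /\ omega_sigma_to_zero K z.
Proof.
  destruct HNw as [_ [_ [Hconn [HM [HB [_ [Hw Hlip]]]]]]].
  assert (Hw0 : forall j, 0 < w0 Nw j) by (intro j; apply Hw).
  pose proof (equilibrium_om_zero Nw zs Heq Hconn A2) as om_star.
  pose proof (equilibrium_power_balance Nw zs Heq HM Hw om_star) as bal.
  destruct (storage_choice Nw (hx zs) Hw0 A3) as [V [G [ph [HC1 [Hph [r1 [Hr1 Hstore]]]]]]].
  destruct (fin_common_radius _ (fun e r => Rabs (eta (hx zs) e) + r < PI / 2)) as [r2 [Hr2 Hangle]];
    [intros; lra|intro e; exists ((PI/2 - Rabs (eta (hx zs) e)) / 2); specialize (A4 e); split; lra|].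
  set (r := Rmin r1 r2). pose proof (Rmin_l r1 r2). pose proof (Rmin_r r1 r2).
  assert (Hstore' : forall j, storage_on_box Nw (hx zs) j (V j) (G j) (ph j) r)
    by (intro j; apply (storage_on_box_mono _ _ _ _ _ _ r1); [split; [apply Rmin_pos|]|]; auto).
  destruct (lyapunov_attractivity Nw HM HB Hw Hlip (hx zs) om_star bal V G ph HC1 Hph r
              (Rmin_pos _ _ Hr1 Hr2) (fun j => proj1 (Hstore' j)) (fun j => proj1 (proj2 (Hstore' j)))
              (fun j => proj2 (proj2 (Hstore' j))) ltac:(intro e; specialize (Hangle e); unfold r; lra)
              (fun j => A1ii j 0)) as [S [HS1 [HS2 HS3]]].
  exists S. split; [|split]; auto. intros K z [Hsol _]. apply HS3, Hsol.
Qed.
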